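(* Let $\Phi\in C^1(V,\mathbb{R})$ be twice continuously differentiable on a neighbourhood of $B_{++}$, with $\nabla\Phi(w,u)\in V_{++}$ for all $(w,u)\in S_+\cup B_{++}$, so that $G^\Phi:B_{++}\to B_{++}$ is well defined. Suppose there is a matrix $A\in\mathbb{R}^{(K+1)\times(K+1)}_+$ such that $F=G^\Phi$ and $A$ satisfy, for all $i,k\in[K]$, $j,a\in[n_1]$, $b\in[d]$ and $(w,u)\in B_{++}$, $$\langle|\nabla_{w_k}F_{w_{i,j}}|,w_k\rangle\le A_{i,k}F_{w_{i,j}},\ \ \langle|\nabla_u F_{w_{i,j}}|,u\rangle\le A_{i,K+1}F_{w_{i,j}},\ \ \langle|\nabla_{w_k}F_{u_{ab}}|,w_k\rangle\le A_{K+1,k}F_{u_{ab}},\ \ \langle|\nabla_u F_{u_{ab}}|,u\rangle\le A_{K+1,K+1}F_{u_{ab}}$$ (all evaluated at $(w,u)$), and that $A^T$ has an eigenvector $\gamma\in\mathbb{R}^{K+1}_{++}$. If $\rho(A)<1$, then $\Phi$ has a unique critical point $(w^*,u^* )$ on $S_{++}$ (in the sense of existence of Lagrange multipliers $\lambda_j$ with $\nabla_{w_j}\Phi=\lambda_j\psi_{p_w}(w_j)$, $\nabla_u\Phi=\lambda_{K+1}\psi_{p_u}(u)$), and it is the global maximizer of $\Phi$ on $S_+$. Moreover, for every $(w^0,u^0)\in S_{++}$ the sequence $(w^{k+1},u^{k+1})=G^\Phi(w^k,u^k)$ converges to $(w^*,u^* )$ and $$\|(w^k,u^k)-(w^*,u^*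 )\|_\infty\le\rho(A)^k\,\frac{\mu_\gamma\big((w^1,u^1),(w^0,u^0)\big)}{(1-\rho(A))\min\big\{\frac{\gamma_{K+1}}{\rho_u},\min_{t\in[K]}\frac{\gamma_t}{\rho_w}\big\}}\qquad\forall k\in\mathbb{N}.$$
   Context: $\mathbb{R}_+=[0,\infty)$, $\mathbb{R}_{++}=(0,\infty)$. $V=\mathbb{R}^{K\times n_1}\times\mathbb{R}^{n_1\times d}$, $V_{++}=\mathbb{R}^{K\times n_1}_{++}\times\mathbb{R}^{n_1\times d}_{++}$; $w$ has rows $w_1,\dots,w_K$; $\|\cdot\|_p$ of a matrix is the entrywise $\ell_p$ norm; $\|\cdot\|_\infty$ is the maximum absolute entry. Given $p_w,p_u\in(1,\infty)$ and $\rho_w,\rho_u>0$: $S_+=\{(w,u)\in\mathbb{R}^{K\times n_1}_+\times\mathbb{R}^{n_1\times d}_+ : \|u\|_{p_u}=\rho_u,\ \|w_i\|_{p_w}=\rho_w\ \forall i\}$, $S_{++}=S_+\cap V_{++}$, $B_{++}=\{(w,u)\in V_{++} : \|u\|_{p_u}\le\rho_u,\ \|w_i\|_{p_w}\le\rho_w\ \forall i\}$. For $p\in(1,\infty)$, $p'=p/(p-1)$, $\psi_p(z)=\operatorname{sign}(z)|z|^{p-1}$ componentwise. $$G^{\Phi}(w,u)=\Big(\tfrac{\rho_w\psi_{p_w'}(\nabla_{w_1}\Phi)}{\|\psi_{p_w'}(\nabla_{w_1}\Phi)\|_{p_w}},\dots,\tfrac{\rho_w\psi_{p_w'}(\nabla_{w_K}\Phi)}{\|\psi_{p_w'}(\nabla_{w_K}\Phi)\|_{p_w}},\tfrac{\rho_u\psi_{p_u'}(\nabla_u\Phi)}{\|\psi_{p_u'}(\nabla_u\Phi)\|_{p_u}}\Big)(w,u),$$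 with components $F_{w_{i,j}}$, $F_{u_{ab}}$ of $F=G^\Phi$. $|\cdot|$ is entrywise absolute value, $\langle\cdot,\cdot\rangle$ the Frobenius inner product, $\rho(A)$ the spectral radius. For $\gamma\in\mathbb{R}^{K+1}_{++}$, $\mu_\gamma((w,u),(\tilde w,\tilde u))=\sum_{i=1}^K\gamma_i\|\ln w_i-\ln\tilde w_i\|_\infty+\gamma_{K+1}\|\ln u-\ln\tilde u\|_\infty$ ($\ln$ entrywise). *)

From Stdlib Require Import Reals Lra Lia Arith Bool ClassicalEpsilon.
Open Scope R_scope.

(* Coordinates of V = R^{K x n1} x R^{n1 x d}:  CW i j = w_{i,j},  CU a b = u_{a,b}
   (0-based indices).  A point of V is a function Co -> R which vanishes
   outside the index range (see [supp]). *)
Inductive Co : Type := CW (i j : nat) | CU (a b : nat).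

Definition Co_eqb (c c' : Co) : bool :=
  match c, c' with
  | CW i j, CW i' j' => Nat.eqb i i' && Nat.eqb j j'
  | CU a b, CU a' b' => Nat.eqb a a' && Nat.eqb b b'
  | _, _ => false
  end.

Definition inR (K n1 d : nat) (c : Co) : bool :=
  match c with
  | CW i j => Nat.ltb i K && Nat.ltb j n1
  | CU a b => Nat.ltb a n1 && Nat.ltb b d
  end.

Definition Pt := Co -> R.

Definition supp (K n1 d : nat) (x : Pt) : Prop :=
  forall c, inR K n1 d c = false -> x c = 0.

Definition padd (x y : Pt) : Pt := fun c => x c + y c.
Definition pscale (t : R) (x : Pt) : Pt := fun c => t * x c.
Definition ebas (c : Co) : Pt := fun c' => if Co_eqb c c' then 1 else 0.

Fixpoint rsum (m : nat) (f : nat -> R) : R :=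
  match m with O => 0 | S m' => rsum m' f + f m' end.
Fixpoint rmaxn (m : nat) (f : nat -> R) : R :=
  match m with O => 0 | S m' => Rmax (rmaxn m' f) (f m') end.
(* minimum of f 0, ..., f (m-1) (only meaningful for m >= 1) *)
Fixpoint rminn (m : nat) (f : nat -> R) : R :=
  match m with O => f O | S O => f O | S m' => Rmin (rminn m' f) (f m') end.

(* x^q for x >= 0 (with 0^q = 0, q > 0) *)
Definition powp (x q : R) : R :=
  match Rle_lt_dec x 0 with left _ => 0 | right _ => Rpower x q end.

Definition psi (p z : R) : R :=
  match Rlt_dec z 0 with left _ => - powp (- z) (p - 1) | right _ => powp z (p - 1) end.

Definition conjexp (p : R) : R := p / (p - 1).

Definition rownorm (n1 : nat) (p : R) (x : Pt) (i : nat) : R :=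
  powp (rsum n1 (fun j => powp (Rabs (x (CW i j))) p)) (1 / p).
Definition unorm (n1 d : nat) (p : R) (x : Pt) : R :=
  powp (rsum n1 (fun a => rsum d (fun b => powp (Rabs (x (CU a b))) p))) (1 / p).

Definition linf (K n1 d : nat) (x : Pt) : R :=
  Rmax (rmaxn K (fun i => rmaxn n1 (fun j => Rabs (x (CW i j)))))
       (rmaxn n1 (fun a => rmaxn d (fun b => Rabs (x (CU a b))))).

Definition S_plus (K n1 d : nat) (pw pu rw ru : R) (x : Pt) : Prop :=
  supp K n1 d x /\ (forall c, inR K n1 d c = true -> 0 <= x c) /\
  unorm n1 d pu x = ru /\ (forall i, (i < K)%nat -> rownorm n1 pw x i = rw).

Definition S_pp (K n1 d : nat) (pw pu rw ru : R) (x : Pt) : Prop :=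
  S_plus K n1 d pw pu rw ru x /\ (forall c, inR K n1 d c = true -> 0 < x c).

Definition B_pp (K n1 d : nat) (pw pu rw ru : R) (x : Pt) : Prop :=
  supp K n1 d x /\ (forall c, inR K n1 d c = true -> 0 < x c) /\
  unorm n1 d pu x <= ru /\ (forall i, (i < K)%nat -> rownorm n1 pw x i <= rw).

(* partial derivative of f at x in the coordinate direction c
   (the value of the derivative when it exists) *)
Definition pd (f : Pt -> R) (x : Pt) (c : Co) : R :=
  epsilon (inhabits 0)
    (fun l => derivable_pt_lim (fun t => f (padd x (pscale t (ebas c)))) 0 l).

Definition has_pd (f : Pt -> R) (x : Pt) (c : Co) : Prop :=
  exists l, derivable_pt_lim (fun t => f (padd x (pscale t (ebas c)))) 0 l.

Definition grad (K n1 d : nat) (Phi : Pt -> R) (x : Pt) : Pt :=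
  fun c => if inR K n1 d c then pd Phi x c else 0.

Definition cont_on (K n1 d : nat) (U : Pt -> Prop) (g : Pt -> R) : Prop :=
  forall x, U x -> forall eps, 0 < eps -> exists delta, 0 < delta /\
    forall y, U y -> (forall c, inR K n1 d c = true -> Rabs (y c - x c) < delta) ->
      Rabs (g y - g x) < eps.

Definition Vopen (K n1 d : nat) (U : Pt -> Prop) : Prop :=
  forall x, U x -> supp K n1 d x -> exists delta, 0 < delta /\
    forall y, supp K n1 d y ->
      (forall c, inR K n1 d c = true -> Rabs (y c - x c) < delta) -> U y.

Definition Phi_C1 (K n1 d : nat) (Phi : Pt -> R) : Prop :=
  forall c, inR K n1 d c = true ->
    (forall x, supp K n1 d x -> has_pd Phi x c) /\
    cont_on K n1 d (supp K n1 d) (fun x => pd Phi x c).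

Definition C2_on (K n1 d : nat) (U : Pt -> Prop) (Phi : Pt -> R) : Prop :=
  forall c, inR K n1 d c = true ->
    (forall x, U x -> has_pd Phi x c) /\
    cont_on K n1 d U (fun x => pd Phi x c) /\
    forall c', inR K n1 d c' = true ->
      (forall x, U x -> has_pd (fun y => pd Phi y c) x c') /\
      cont_on K n1 d U (fun x => pd (fun y => pd Phi y c) x c').

Definition Gmap (K n1 d : nat) (pw pu rw ru : R) (Phi : Pt -> R) (x : Pt) : Pt :=
  let g := grad K n1 d Phi x in
  let gw := fun c => psi (conjexp pw) (g c) in
  let gu := fun c => psi (conjexp pu) (g c) in
  fun c => if inR K n1 d c then
    match c with
    | CW i j => rw * gw c / rownorm n1 pw gw i
    | CU a b => ru * gu c / unorm n1 d pu gu
    end else 0.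

(* block index of a coordinate: w-row i -> i, u -> K  (0-based; the paper's K+1) *)
Definition blk (K : nat) (c : Co) : nat :=
  match c with CW i _ => i | CU _ _ => K end.

(* Complex eigenvalue a + i b of the real m x m matrix A (indices 0..m-1),
   with eigenvector x + i y <> 0 *)
Definition is_ceigenvalue (m : nat) (A : nat -> nat -> R) (a b : R) : Prop :=
  exists x y : nat -> R,
    (exists k, (k < m)%nat /\ (x k <> 0 \/ y k <> 0)) /\
    forall i, (i < m)%nat ->
      rsum m (fun j => A i j * x j) = a * x i - b * y i /\
      rsum m (fun j => A i j * y j) = b * x i + a * y i.

Definition is_spectral_radius (m : nat) (A : nat -> nat -> R) (r : R) : Prop :=
  (exists a b, is_ceigenvalue m A a b /\ sqrt (a * a + b * b) = r) /\
  (forall a b, is_ceigenvalue m A a b -> sqrt (a * a + b * b) <= r).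

Definition mu (K n1 d : nat) (gam : nat -> R) (x y : Pt) : R :=
  rsum K (fun i => gam i * rmaxn n1 (fun j => Rabs (ln (x (CW i j)) - ln (y (CW i j)))))
  + gam K * rmaxn n1 (fun a => rmaxn d (fun b => Rabs (ln (x (CU a b)) - ln (y (CU a b))))).

Definition crit_pt (K n1 d : nat) (pw pu rw ru : R) (Phi : Pt -> R) (x : Pt) : Prop :=
  S_pp K n1 d pw pu rw ru x /\
  exists lam : nat -> R,
    (forall i j, (i < K)%nat -> (j < n1)%nat ->
       pd Phi x (CW i j) = lam i * psi pw (x (CW i j))) /\
    (forall a b, (a < n1)%nat -> (b < d)%nat ->
       pd Phi x (CU a b) = lam K * psi pu (x (CU a b))).

From Stdlib Require Import Reals Lra Lia Bool List ClassicalEpsilon FunctionalExtensionality Classical.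
From Coquelicot Require Coquelicot.
From mathcomp Require all_boot all_algebra Rstruct.
Open Scope R_scope.
Set Bullet Behavior "Strict Subproofs".

(* [G^Phi] is a contraction of [B_++] for the weighted Thompson metric [mu_gamma]: along the
   coordinatewise log-linear path [t |-> x^(1-t) y^t] the logarithmic derivative of each
   coordinate of [G^Phi] is bounded blockwise by [A], and pairing these bounds with the positive
   left eigenvector [gamma] gives [mu (G x) (G y) <= lam * mu x y] with [lam <= rho(A) < 1].
   A maximizer of [Phi] on the compact set [S_+] exists and is fixed by [G^Phi]: otherwise
   Hoelder's inequality makes [G xh - xh] an ascent direction, and since the gradient is positive
   on [B_++] the improved point can be pushed radially back onto [S_+]. On [S_++] the fixed points
   of [G^Phi] are exactly the critical points, so the contraction gives uniqueness, and the Banach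
   iteration estimate in [mu_gamma], converted to the sup norm through the entry bounds on [S_+],
   gives the convergence rate. *)

(** * Coordinates and finite sums *)

Lemma Co_eqb_spec c c' : Co_eqb c c' = true <-> c = c'.
Proof.
destruct c, c'; simpl; split; intro H; try discriminate;
 try (apply andb_true_iff in H; destruct H as [H1 H2];
      apply Nat.eqb_eq in H1; apply Nat.eqb_eq in H2; subst; reflexivity);
 try (inversion H; subst; rewrite !Nat.eqb_refl; reflexivity).
Qed.

Lemma Co_eqb_refl c : Co_eqb c c = true.
Proof. apply Co_eqb_spec; reflexivity. Qed.

Lemma Co_eqb_neq c c' : c <> c' -> Co_eqb c c' = false.
Proof. intro H. destruct (Co_eqb c c') eqn:E; auto. apply Co_eqb_spec in E. contradiction. Qed.

Lemma Co_eq_dec (c c' : Co) : {c = c'} + {c <> c'}.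
Proof. decide equality; apply Nat.eq_dec. Qed.

Lemma rsum_ext m f g : (forall i, (i < m)%nat -> f i = g i) -> rsum m f = rsum m g.
Proof.
induction m; simpl; intros; auto.
rewrite IHm by (intros; apply H; lia). rewrite H by lia. reflexivity.
Qed.

Lemma rsum_plus m f g : rsum m (fun i => f i + g i) = rsum m f + rsum m g.
Proof. induction m; simpl; [lra|rewrite IHm; lra]. Qed.

Lemma rsum_scal m a f : rsum m (fun i => a * f i) = a * rsum m f.
Proof. induction m; simpl; [lra|rewrite IHm; lra]. Qed.

Lemma rsum_zero m : rsum m (fun _ => 0) = 0.
Proof. induction m; simpl; [lra|rewrite IHm; lra]. Qed.

Lemma rsum_le m f g : (forall i, (i < m)%nat -> f i <= g i) -> rsum m f <= rsum m g.
Proof.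
induction m; simpl; intros; [lra|].
assert (rsum m f <= rsum m g) by (apply IHm; intros; apply H; lia).
assert (f m <= g m) by (apply H; lia). lra.
Qed.

Lemma rsum_lt m f g : (forall i, (i < m)%nat -> f i <= g i) ->
  (exists i, (i < m)%nat /\ f i < g i) -> rsum m f < rsum m g.
Proof.
induction m; simpl; intros H [i [Hi Hlt]]; [lia|].
destruct (Nat.eq_dec i m).
- subst. assert (rsum m f <= rsum m g) by (apply rsum_le; intros; apply H; lia). lra.
- assert (rsum m f < rsum m g) by (apply IHm; [intros; apply H; lia| exists i; split; [lia|auto]]).
  assert (f m <= g m) by (apply H; lia). lra.
Qed.

Lemma rsum_nonneg m f : (forall i, (i < m)%nat -> 0 <= f i) -> 0 <= rsum m f.
Proof. intros. rewrite <- (rsum_zero m). apply rsum_le. auto. Qed.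

Lemma rsum_swap m n (f : nat -> nat -> R) :
  rsum m (fun i => rsum n (fun j => f i j)) = rsum n (fun j => rsum m (fun i => f i j)).
Proof.
induction m; simpl.
- symmetry. apply rsum_zero.
- rewrite IHm. rewrite <- rsum_plus. reflexivity.
Qed.

Lemma rsum_ge_term m f i : (forall k, (k < m)%nat -> 0 <= f k) -> (i < m)%nat -> f i <= rsum m f.
Proof.
induction m; intros; [lia|]. simpl.
destruct (Nat.eq_dec i m).
- subst. assert (0 <= rsum m f) by (apply rsum_nonneg; intros; apply H; lia). lra.
- assert (f i <= rsum m f) by (apply IHm; [intros; apply H; lia|lia]).
  assert (0 <= f m) by (apply H; lia). lra.
Qed.

Lemma rmaxn_nonneg m f : 0 <= rmaxn m f.
Proof. induction m; simpl; [lra|]. eapply Rle_trans; [apply IHm|apply Rmax_l]. Qed.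

Lemma rmaxn_ge m f i : (i < m)%nat -> f i <= rmaxn m f.
Proof.
induction m; intros; [lia|]. simpl.
destruct (Nat.eq_dec i m).
- subst. apply Rmax_r.
- eapply Rle_trans; [apply IHm; lia|apply Rmax_l].
Qed.

Lemma rmaxn_le m f B : 0 <= B -> (forall i, (i < m)%nat -> f i <= B) -> rmaxn m f <= B.
Proof.
induction m; simpl; intros; auto.
apply Rmax_lub; [apply IHm; auto|apply H0; lia].
Qed.

Lemma rmaxn_ext m f g : (forall i, (i < m)%nat -> f i = g i) -> rmaxn m f = rmaxn m g.
Proof.
induction m; simpl; intros; auto.
rewrite IHm by (intros; apply H; lia). rewrite H by lia. reflexivity.
Qed.

Lemma rmaxn_mono m f g : (forall i, (i < m)%nat -> f i <= g i) -> rmaxn m f <= rmaxn m g.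
Proof.
intros. apply rmaxn_le; [apply rmaxn_nonneg|].
intros. eapply Rle_trans; [apply H; auto|apply rmaxn_ge; auto].
Qed.

Lemma rmaxn_add m f g : (forall i, (i < m)%nat -> 0 <= f i) -> (forall i, (i < m)%nat -> 0 <= g i) ->
  rmaxn m (fun i => f i + g i) <= rmaxn m f + rmaxn m g.
Proof.
intros. apply rmaxn_le.
- pose proof (rmaxn_nonneg m f); pose proof (rmaxn_nonneg m g); lra.
- intros. pose proof (rmaxn_ge m f i H1); pose proof (rmaxn_ge m g i H1); lra.
Qed.

Lemma rminn_le m f i : (i < m)%nat -> rminn m f <= f i.
Proof.
induction m; intros; [lia|].
destruct m.
- simpl. assert (i = 0%nat) by lia. subst. lra.
- change (rminn (S (S m)) f) with (Rmin (rminn (S m) f) (f (S m))).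
  destruct (Nat.eq_dec i (S m)).
  + subst. apply Rmin_r.
  + eapply Rle_trans; [apply Rmin_l|apply IHm; lia].
Qed.

Lemma rminn_pos m f : (forall i, (i <= m)%nat -> 0 < f i) -> 0 < rminn m f.
Proof.
induction m; intros; simpl; [apply H; lia|].
destruct m; [apply H; lia|].
apply Rmin_glb_lt; [apply IHm; intros; apply H; lia|apply H; lia].
Qed.

Section ListSums.
Context {T : Type}.
Implicit Types (L : list T) (f g : T -> R).

Fixpoint lsum (L : list T) (f : T -> R) : R :=
  match L with nil => 0 | c :: L' => f c + lsum L' f end.

Lemma lsum_app L1 L2 f : lsum (L1 ++ L2) f = lsum L1 f + lsum L2 f.
Proof. induction L1; simpl; [lra|rewrite IHL1; lra]. Qed.

Lemma lsum_map_seq (g : nat -> T) m f : lsum (map g (seq 0 m)) f = rsum m (fun i => f (g i)).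
Proof.
induction m; auto.
rewrite seq_S, map_app, lsum_app, IHm. simpl. lra.
Qed.

Lemma lsum_flat_map_seq (g : nat -> list T) m f :
  lsum (flat_map g (seq 0 m)) f = rsum m (fun i => lsum (g i) f).
Proof.
induction m; auto.
rewrite seq_S, flat_map_app, lsum_app, IHm. simpl. rewrite app_nil_r. reflexivity.
Qed.

Lemma NoDup_flat_map_seq (g : nat -> list T) m :
  (forall i, NoDup (g i)) -> (forall i j c, i <> j -> In c (g i) -> In c (g j) -> False) ->
  NoDup (flat_map g (seq 0 m)).
Proof.
intros Hg Hd. induction m; [constructor|].
rewrite seq_S, flat_map_app. simpl. rewrite app_nil_r.
apply NoDup_app; auto.
intros c Hc1 Hc2. apply in_flat_map in Hc1. destruct Hc1 as [i [Hi Hc]].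
apply in_seq in Hi. apply (Hd i m c); auto. lia.
Qed.

Lemma lsum_ext L f g : (forall c, In c L -> f c = g c) -> lsum L f = lsum L g.
Proof. induction L; simpl; intros; auto. rewrite H, IHL; auto. Qed.

Lemma lsum_le L f g : (forall c, In c L -> f c <= g c) -> lsum L f <= lsum L g.
Proof.
induction L; simpl; intros; [lra|].
assert (f a <= g a) by auto. assert (lsum L f <= lsum L g) by auto. lra.
Qed.

Lemma lsum_plus L f g : lsum L (fun c => f c + g c) = lsum L f + lsum L g.
Proof. induction L; simpl; [lra|rewrite IHL; lra]. Qed.

Lemma lsum_minus L f g : lsum L (fun c => f c - g c) = lsum L f - lsum L g.
Proof. induction L; simpl; [lra|rewrite IHL; lra]. Qed.

Lemma lsum_scal L a f : lsum L (fun c => a * f c) = a * lsum L f.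
Proof. induction L; simpl; [lra|rewrite IHL; lra]. Qed.

Lemma lsum_abs L f : Rabs (lsum L f) <= lsum L (fun c => Rabs (f c)).
Proof.
induction L; simpl; [rewrite Rabs_R0; lra|].
eapply Rle_trans; [apply Rabs_triang|lra].
Qed.

Lemma lsum_nonneg L f : (forall c, In c L -> 0 <= f c) -> 0 <= lsum L f.
Proof. induction L; simpl; intros; [lra|]. assert (0 <= f a) by auto. assert (0 <= lsum L f) by auto. lra. Qed.

Lemma lsum_lt L f g : (forall c, In c L -> f c <= g c) -> (exists c, In c L /\ f c < g c) -> lsum L f < lsum L g.
Proof.
induction L; simpl; intros H [c [Hc Hlt]]; [tauto|].
destruct Hc as [Hc|Hc].
- subst. assert (lsum L f <= lsum L g) by (apply lsum_le; auto). lra.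
- assert (lsum L f < lsum L g) by (apply IHL; auto; exists c; auto).
  assert (f a <= g a) by auto. lra.
Qed.

Lemma lsum_le_length L f a : (forall c, In c L -> f c <= a) -> lsum L f <= INR (length L) * a.
Proof.
induction L as [|c0 L IH]; intros H; [simpl; lra|].
change (f c0 + lsum L f <= INR (S (length L)) * a). rewrite S_INR.
assert (f c0 <= a) by (apply H; left; auto).
assert (lsum L f <= INR (length L) * a) by (apply IH; intros c Hc; apply H; right; auto). lra.
Qed.

Lemma lsum_ge_term L f c : (forall c', In c' L -> 0 <= f c') -> In c L -> f c <= lsum L f.
Proof.
induction L; simpl; [tauto|]. intros H [Hc|Hc].
- subst. assert (0 <= lsum L f) by (apply lsum_nonneg; auto). lra.
- assert (f c <= lsum L f) by auto. assert (0 <= f a) by auto. lra.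
Qed.

Lemma common_delta (L : list T) (P : T -> R -> Prop) :
  (forall c d1 d2, 0 < d1 -> d1 <= d2 -> P c d2 -> P c d1) ->
  (forall c, In c L -> exists d, 0 < d /\ P c d) ->
  exists d, 0 < d /\ forall c, In c L -> P c d.
Proof.
intros Hm. induction L; intros H.
- exists 1. split; [lra|]. intros c [].
- destruct (H a (or_introl eq_refl)) as [d1 [Hd1 Pd1]].
  destruct IHL as [d2 [Hd2 Pd2]]; [intros; apply H; right; auto|].
  exists (Rmin d1 d2). split; [apply Rmin_pos; auto|].
  intros c [Hc|Hc].
  + subst. apply (Hm c _ d1); auto; [apply Rmin_pos; auto|apply Rmin_l].
  + apply (Hm c _ d2); auto; [apply Rmin_pos; auto|apply Rmin_r].
Qed.

End ListSums.

Definition allsum (K n1 d : nat) (f : Co -> R) : R :=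
  rsum K (fun i => rsum n1 (fun j => f (CW i j))) + rsum n1 (fun a => rsum d (fun b => f (CU a b))).

Definition coords (K n1 d : nat) : list Co :=
  flat_map (fun i => map (CW i) (seq 0 n1)) (seq 0 K) ++
  flat_map (fun a => map (CU a) (seq 0 d)) (seq 0 n1).

Lemma lsum_coords K n1 d f : lsum (coords K n1 d) f = allsum K n1 d f.
Proof.
unfold coords, allsum. rewrite lsum_app, !lsum_flat_map_seq.
f_equal; apply rsum_ext; intros; apply lsum_map_seq.
Qed.

Lemma In_coords K n1 d c : In c (coords K n1 d) <-> inR K n1 d c = true.
Proof.
unfold coords. rewrite in_app_iff, !in_flat_map.
destruct c; simpl; rewrite andb_true_iff, !Nat.ltb_lt; split.
- intros [[x [Hx Hm]]|[x [Hx Hm]]]; apply in_map_iff in Hm; destruct Hm as [y [Hy Hy']];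
  try discriminate. inversion Hy; subst. apply in_seq in Hx; apply in_seq in Hy'. lia.
- intros [H1 H2]. left. exists i. split; [apply in_seq; lia|]. apply in_map_iff. exists j. split; auto. apply in_seq; lia.
- intros [[x [Hx Hm]]|[x [Hx Hm]]]; apply in_map_iff in Hm; destruct Hm as [y [Hy Hy']];
  try discriminate. inversion Hy; subst. apply in_seq in Hx; apply in_seq in Hy'. lia.
- intros [H1 H2]. right. exists a. split; [apply in_seq; lia|]. apply in_map_iff. exists b. split; auto. apply in_seq; lia.
Qed.

Lemma NoDup_coords K n1 d : NoDup (coords K n1 d).
Proof.
unfold coords. apply NoDup_app.
- apply NoDup_flat_map_seq.
  + intros. apply NoDup_map_inv with (f := fun c => match c with CW _ j => j | CU _ b => b end); rewrite map_map; simpl; rewrite map_id; apply seq_NoDup.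
  + intros i j c Hij H1 H2. apply in_map_iff in H1, H2.
    destruct H1 as [a [Ha _]], H2 as [b [Hb _]]. subst. inversion Hb. auto.
- apply NoDup_flat_map_seq.
  + intros. apply NoDup_map_inv with (f := fun c => match c with CW _ j => j | CU _ b => b end); rewrite map_map; simpl; rewrite map_id; apply seq_NoDup.
  + intros i j c Hij H1 H2. apply in_map_iff in H1, H2.
    destruct H1 as [a [Ha _]], H2 as [b [Hb _]]. subst. inversion Hb. auto.
- intros c H1 H2. apply in_flat_map in H1, H2.
  destruct H1 as [i [_ H1]], H2 as [j [_ H2]].
  apply in_map_iff in H1, H2. destruct H1 as [a [Ha _]], H2 as [b [Hb _]]. subst. discriminate.
Qed.

Lemma allsum_ext K n1 d f g : (forall c, inR K n1 d c = true -> f c = g c) -> allsum K n1 d f = allsum K n1 d g.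
Proof.
intros. rewrite <- !lsum_coords. apply lsum_ext. intros. apply H, In_coords; auto.
Qed.

Lemma allsum_le K n1 d f g : (forall c, inR K n1 d c = true -> f c <= g c) -> allsum K n1 d f <= allsum K n1 d g.
Proof.
intros. rewrite <- !lsum_coords. apply lsum_le. intros. apply H, In_coords; auto.
Qed.

Lemma allsum_nonneg K n1 d f : (forall c, inR K n1 d c = true -> 0 <= f c) -> 0 <= allsum K n1 d f.
Proof. intros. rewrite <- !lsum_coords. apply lsum_nonneg. intros. apply H, In_coords; auto. Qed.

Lemma allsum_abs K n1 d f : Rabs (allsum K n1 d f) <= allsum K n1 d (fun c => Rabs (f c)).
Proof. rewrite <- !lsum_coords. apply lsum_abs. Qed.

Lemma allsum_ge_term K n1 d f c : (forall c', inR K n1 d c' = true -> 0 <= f c') ->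
  inR K n1 d c = true -> f c <= allsum K n1 d f.
Proof. intros H Hc. rewrite <- lsum_coords. apply lsum_ge_term; [|apply In_coords; auto]. intros; apply H, In_coords; auto. Qed.

Lemma allsum_plus K n1 d f g : allsum K n1 d (fun c => f c + g c) = allsum K n1 d f + allsum K n1 d g.
Proof. rewrite <- !lsum_coords. apply lsum_plus. Qed.

Lemma allsum_scal K n1 d a f : allsum K n1 d (fun c => a * f c) = a * allsum K n1 d f.
Proof. rewrite <- !lsum_coords. apply lsum_scal. Qed.

Lemma allsum_minus K n1 d f g : allsum K n1 d (fun c => f c - g c) = allsum K n1 d f - allsum K n1 d g.
Proof.
rewrite (allsum_ext K n1 d _ (fun c => f c + (-1) * g c)) by (intros; ring).
rewrite allsum_plus, allsum_scal. ring.
Qed.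

(** * Partial derivatives, [C^1] functions and the chain rule *)

Section AffineDerivatives.
Import Coquelicot.Coquelicot.

Lemma derivable_pt_lim_affine a b t0 : derivable_pt_lim (fun t => a + t * b) t0 b.
Proof. apply is_derive_Reals. auto_derive; auto. ring. Qed.

Lemma derivable_pt_lim_affine_mult a b w t0 :
  derivable_pt_lim (fun t => (a + t * b) * w) t0 (b * w).
Proof. apply is_derive_Reals. auto_derive; auto. ring. Qed.

Lemma derivable_pt_lim_exp_interp a b t0 :
  derivable_pt_lim (fun t => exp ((1 - t) * a + t * b)) t0
    (exp ((1 - t0) * a + t0 * b) * (b - a)).
Proof. apply is_derive_Reals. auto_derive; auto. replace (1 + - t0) with (1 - t0) by ring. ring. Qed.

End AffineDerivatives.

Definition upd (x : Pt) (c : Co) (v : R) : Pt := fun c' => if Co_eqb c c' then v else x c'.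

Lemma upd_eq x c v : upd x c v c = v.
Proof. unfold upd. rewrite Co_eqb_refl. auto. Qed.

Lemma upd_neq x c c' v : c <> c' -> upd x c v c' = x c'.
Proof. intros. unfold upd. rewrite Co_eqb_neq; auto. Qed.

Lemma upd_same x c : upd x c (x c) = x.
Proof.
apply functional_extensionality. intro c'. unfold upd.
destruct (Co_eqb c c') eqn:E; auto. apply Co_eqb_spec in E. subst. auto.
Qed.

Lemma upd_upd x c v w : upd (upd x c v) c w = upd x c w.
Proof.
apply functional_extensionality. intro c'. unfold upd.
destruct (Co_eqb c c'); auto.
Qed.

Lemma padd_ebas_upd x c t : padd x (pscale t (ebas c)) = upd x c (x c + t).
Proof.
apply functional_extensionality. intro c'. unfold padd, pscale, ebas, upd.
destruct (Co_eqb c c') eqn:E.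
- apply Co_eqb_spec in E. subst. ring.
- ring.
Qed.

Lemma padd_ebas_0 (f : Pt -> R) x c : f (padd x (pscale 0 (ebas c))) = f x.
Proof. rewrite padd_ebas_upd. replace (x c + 0) with (x c) by ring. rewrite upd_same. auto. Qed.

Lemma pd_spec f x c : has_pd f x c ->
  derivable_pt_lim (fun t => f (padd x (pscale t (ebas c)))) 0 (pd f x c).
Proof. intros H. unfold pd. apply epsilon_spec. exact H. Qed.

Lemma pd_unique f x c l :
  derivable_pt_lim (fun t => f (padd x (pscale t (ebas c)))) 0 l -> pd f x c = l.
Proof. intros H. eapply uniqueness_limite; [apply pd_spec; exists l; exact H|exact H]. Qed.

Lemma derivable_pt_lim_upd f p c s : has_pd f (upd p c s) c ->
  derivable_pt_lim (fun s => f (upd p c s)) s (pd f (upd p c s) c).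
Proof.
intros H. apply pd_spec in H.
intros eps Heps. destruct (H eps Heps) as [del Hdel].
exists del. intros h Hh Hhd.
specialize (Hdel h Hh Hhd).
rewrite !padd_ebas_upd, !upd_upd, upd_eq in Hdel.
replace (s + (0 + h)) with (s + h) in Hdel by ring. replace (s + 0) with s in Hdel by ring. exact Hdel.
Qed.

Lemma pd_const a x c : has_pd (fun _ => a) x c /\ pd (fun _ => a) x c = 0.
Proof.
assert (H : derivable_pt_lim (fun t => (fun _ : Pt => a) (padd x (pscale t (ebas c)))) 0 0)
  by apply derivable_pt_lim_const.
split; [exists 0; auto|apply pd_unique; auto].
Qed.

Lemma pd_plus f g x c : has_pd f x c -> has_pd g x c ->
  has_pd (fun y => f y + g y) x c /\ pd (fun y => f y + g y) x c = pd f x c + pd g x c.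
Proof.
intros Hf Hg. apply pd_spec in Hf, Hg.
assert (H : derivable_pt_lim (fun t => (fun y => f y + g y) (padd x (pscale t (ebas c)))) 0 (pd f x c + pd g x c))
  by (apply (derivable_pt_lim_plus (fun t => f (padd x (pscale t (ebas c)))) (fun t => g (padd x (pscale t (ebas c))))); auto).
split; [eexists; eauto|apply pd_unique; auto].
Qed.

Lemma pd_mult f g x c : has_pd f x c -> has_pd g x c ->
  has_pd (fun y => f y * g y) x c /\ pd (fun y => f y * g y) x c = pd f x c * g x + f x * pd g x c.
Proof.
intros Hf Hg. apply pd_spec in Hf, Hg.
pose proof (derivable_pt_lim_mult (fun t => f (padd x (pscale t (ebas c)))) (fun t => g (padd x (pscale t (ebas c)))) 0 _ _ Hf Hg) as H.
simpl in H. rewrite (padd_ebas_0 f), (padd_ebas_0 g) in H.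
split; [eexists; exact H|apply pd_unique; exact H].
Qed.

Lemma pd_comp (h h' : R -> R) f x c : has_pd f x c -> derivable_pt_lim h (f x) (h' (f x)) ->
  has_pd (fun y => h (f y)) x c /\ pd (fun y => h (f y)) x c = h' (f x) * pd f x c.
Proof.
intros Hf Hh. apply pd_spec in Hf.
assert (Hh' : derivable_pt_lim h ((fun t => f (padd x (pscale t (ebas c)))) 0) (h' (f x)))
  by (simpl; rewrite padd_ebas_0; auto).
pose proof (derivable_pt_lim_comp _ h 0 _ _ Hf Hh') as H.
split; [eexists; exact H|apply pd_unique; exact H].
Qed.

Lemma MVT_linear_bound (g g' : R -> R) a b L eps :
  (forall s, Rmin a b <= s <= Rmax a b -> derivable_pt_lim g s (g' s)) ->
  (forall s, Rmin a b <= s <= Rmax a b -> Rabs (g' s - L) <= eps) ->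
  Rabs (g b - g a - L * (b - a)) <= eps * Rabs (b - a).
Proof.
intros Hd Hb.
destruct (Rtotal_order a b) as [Hab|[Hab|Hab]].
- destruct (MVT_cor2 g g' a b Hab) as [xi [Hxi Hr]].
  { intros; apply Hd. rewrite Rmin_left, Rmax_right by lra. lra. }
  rewrite Hxi. replace (g' xi * (b - a) - L * (b - a)) with ((g' xi - L) * (b - a)) by ring.
  rewrite Rabs_mult. apply Rmult_le_compat_r; [apply Rabs_pos|].
  apply Hb. rewrite Rmin_left, Rmax_right by lra. lra.
- subst. replace (g b - g b - L * (b - b)) with 0 by ring. rewrite Rabs_R0.
  pose proof (Rabs_pos (b - b)). assert (0 <= eps).
  { eapply Rle_trans; [apply Rabs_pos|apply (Hb b)]. unfold Rmin, Rmax; destruct Rle_dec; lra. }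
  nra.
- destruct (MVT_cor2 g g' b a Hab) as [xi [Hxi Hr]].
  { intros; apply Hd. rewrite Rmin_right, Rmax_left by lra. lra. }
  replace (g b - g a - L * (b - a)) with (- ((g a - g b) - L * (a - b))) by ring.
  rewrite Rabs_Ropp, Hxi, (Rabs_minus_sym b a).
  replace (g' xi * (a - b) - L * (a - b)) with ((g' xi - L) * (a - b)) by ring.
  rewrite Rabs_mult. apply Rmult_le_compat_r; [apply Rabs_pos|].
  apply Hb. rewrite Rmin_right, Rmax_left by lra. lra.
Qed.

Lemma upd_increment_bound f p c v L eps :
  (forall s, Rmin (p c) v <= s <= Rmax (p c) v ->
     has_pd f (upd p c s) c /\ Rabs (pd f (upd p c s) c - L) <= eps) ->
  Rabs (f (upd p c v) - f p - L * (v - p c)) <= eps * Rabs (v - p c).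
Proof.
intros H. rewrite <- (upd_same p c) at 2.
apply (MVT_linear_bound (fun s => f (upd p c s)) (fun s => pd f (upd p c s) c)).
- intros s Hs. apply derivable_pt_lim_upd, H, Hs.
- intros s Hs. apply H, Hs.
Qed.

Lemma continuity_pt_eps h a : continuity_pt h a ->
  forall eps, 0 < eps -> exists del, 0 < del /\ forall y, Rabs (y - a) < del -> Rabs (h y - h a) < eps.
Proof.
intros H eps Heps. destruct (H eps Heps) as [del [Hdel H']].
exists del. split; auto. intros y Hy.
destruct (Req_dec y a).
- subst. replace (h a - h a) with 0 by ring. rewrite Rabs_R0. auto.
- apply (H' y). split; [split; [exact I|auto]|]. simpl. unfold R_dist. auto.
Qed.

Lemma Rabs_div_lt a h eps : h <> 0 -> Rabs a < eps * Rabs h -> Rabs (a / h) < eps.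
Proof.
intros Hh H. assert (0 < Rabs h) by (apply Rabs_pos_lt; auto).
unfold Rdiv. rewrite Rabs_mult, Rabs_inv.
apply (Rmult_lt_reg_r (Rabs h)); auto. rewrite Rmult_assoc, Rinv_l; lra.
Qed.

Definition upd_list (x y : Pt) (L : list Co) : Pt :=
  fold_right (fun c p => upd p c (y c)) x L.

Lemma upd_list_in x y L c : In c L -> upd_list x y L c = y c.
Proof.
induction L; simpl; [tauto|]; intros [H|H].
- subst. apply upd_eq.
- unfold upd. destruct (Co_eqb a c) eqn:E; [apply Co_eqb_spec in E; subst; auto|apply IHL; auto].
Qed.

Lemma upd_list_notin x y L c : ~ In c L -> upd_list x y L c = x c.
Proof.
induction L; simpl; intros H; auto.
rewrite upd_neq; [apply IHL; tauto|]. intro; apply H; auto.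
Qed.

Lemma upd_list_between x y L c : Rabs (upd_list x y L c - x c) <= Rabs (y c - x c).
Proof.
destruct (in_dec Co_eq_dec c L).
- rewrite upd_list_in; auto; lra.
- rewrite upd_list_notin; auto. replace (x c - x c) with 0 by ring. rewrite Rabs_R0. apply Rabs_pos.
Qed.

Section Calculus.
Variables K n1 d : nat.
Implicit Types (x y p : Pt) (O : Pt -> Prop) (f g : Pt -> R).

Definition near x y (del : R) : Prop :=
  forall c, inR K n1 d c = true -> Rabs (y c - x c) < del.

Lemma near_le x y d1 d2 : d1 <= d2 -> near x y d1 -> near x y d2.
Proof. intros H N c Hc. specialize (N c Hc). lra. Qed.

Lemma near_Rmin x y d1 d2 : near x y (Rmin d1 d2) -> near x y d1 /\ near x y d2.
Proof. intros N. split; eapply near_le; eauto; [apply Rmin_l|apply Rmin_r]. Qed.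

Lemma supp_upd x c v : supp K n1 d x -> inR K n1 d c = true -> supp K n1 d (upd x c v).
Proof.
intros Hs Hc c' Hc'. unfold upd. destruct (Co_eqb c c') eqn:E.
- apply Co_eqb_spec in E. subst. congruence.
- apply Hs; auto.
Qed.

Lemma upd_list_coords x y : supp K n1 d x -> supp K n1 d y -> upd_list x y (coords K n1 d) = y.
Proof.
intros Hx Hy. apply functional_extensionality. intro c.
destruct (inR K n1 d c) eqn:E.
- apply upd_list_in, In_coords; auto.
- rewrite upd_list_notin; [rewrite Hx, Hy; auto|]. rewrite In_coords. congruence.
Qed.

Lemma supp_upd_list x y L : supp K n1 d x -> supp K n1 d y -> supp K n1 d (upd_list x y L).
Proof.
intros Hx Hy c Hc. destruct (in_dec Co_eq_dec c L).
- rewrite upd_list_in; auto.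
- rewrite upd_list_notin; auto.
Qed.

Lemma near_upd_upd_list x y L c s del : near x y del ->
  Rmin (x c) (y c) <= s <= Rmax (x c) (y c) -> near x (upd (upd_list x y L) c s) del.
Proof.
intros Hy Hs c' Hc'. specialize (Hy c' Hc'). destruct (Co_eq_dec c c').
- subst. rewrite upd_eq. unfold Rmin, Rmax in Hs.
  destruct (Rle_dec (x c') (y c')); [rewrite Rabs_right in *|rewrite Rabs_left1 in *]; lra.
- rewrite upd_neq by auto. pose proof (upd_list_between x y L c'). lra.
Qed.

Lemma cont_on_ext O f g : (forall x, O x -> f x = g x) -> cont_on K n1 d O f -> cont_on K n1 d O g.
Proof.
intros E H x Ox eps Heps. destruct (H x Ox eps Heps) as [del [Hd H']].
exists del. split; auto. intros y Oy Hy. rewrite <- !E; auto.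
Qed.

Lemma cont_on_sub (U O : Pt -> Prop) f :
  (forall x, O x -> U x) -> cont_on K n1 d U f -> cont_on K n1 d O f.
Proof.
intros HOU H x Ox eps Heps. destruct (H x (HOU x Ox) eps Heps) as [del [Hd H']].
exists del. split; auto.
Qed.

Lemma cont_on_const O a : cont_on K n1 d O (fun _ => a).
Proof.
intros x Ox eps Heps. exists 1. split; [lra|]. intros. replace (a - a) with 0 by ring. rewrite Rabs_R0; auto.
Qed.

Lemma cont_on_comp O f h : cont_on K n1 d O f -> (forall x, O x -> continuity_pt h (f x)) ->
  cont_on K n1 d O (fun x => h (f x)).
Proof.
intros Hf Hh x Ox eps Heps.
destruct (continuity_pt_eps h (f x) (Hh x Ox) eps Heps) as [d1 [Hd1 H1]].
destruct (Hf x Ox d1 Hd1) as [d2 [Hd2 H2]].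
exists d2. split; [auto|]. intros y Oy Hy. apply H1. apply H2; auto.
Qed.

Lemma cont_on_common_delta O f g x e : cont_on K n1 d O f -> cont_on K n1 d O g -> O x -> 0 < e ->
  exists del, 0 < del /\ forall y, O y -> near x y del ->
    Rabs (f y - f x) < e /\ Rabs (g y - g x) < e.
Proof.
intros Hf Hg Ox He.
destruct (Hf x Ox e He) as [d1 [Hd1 H1]], (Hg x Ox e He) as [d2 [Hd2 H2]].
exists (Rmin d1 d2). split; [apply Rmin_pos; auto|].
intros y Oy Hy. apply near_Rmin in Hy. split; [apply H1|apply H2]; tauto.
Qed.

Lemma cont_on_plus O f g : cont_on K n1 d O f -> cont_on K n1 d O g ->
  cont_on K n1 d O (fun x => f x + g x).
Proof.
intros Hf Hg x Ox eps Heps.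
destruct (cont_on_common_delta O f g x (eps / 2) Hf Hg Ox) as [del [Hdel H]]; [lra|].
exists del. split; auto. intros y Oy Hy. destruct (H y Oy Hy) as [H1 H2].
replace (f y + g y - (f x + g x)) with ((f y - f x) + (g y - g x)) by ring.
eapply Rle_lt_trans; [apply Rabs_triang|]. lra.
Qed.

Lemma cont_on_mult O f g : cont_on K n1 d O f -> cont_on K n1 d O g ->
  cont_on K n1 d O (fun x => f x * g x).
Proof.
intros Hf Hg x Ox eps Heps.
set (M := Rabs (f x) + Rabs (g x) + 1).
assert (HM : 1 <= M) by (unfold M; pose proof (Rabs_pos (f x)); pose proof (Rabs_pos (g x)); lra).
set (e := Rmin 1 (eps / (2 * M))).
assert (He : 0 < e) by (apply Rmin_pos; [lra|apply Rdiv_lt_0_compat; lra]).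
assert (He1 : e <= 1) by apply Rmin_l.
assert (He2 : e * (2 * M) <= eps).
{ assert (e <= eps / (2 * M)) by apply Rmin_r.
  apply (Rmult_le_compat_r (2 * M)) in H; [|lra]. unfold Rdiv in H.
  rewrite Rmult_assoc, Rinv_l in H by lra. lra. }
destruct (cont_on_common_delta O f g x e Hf Hg Ox He) as [del [Hdel H]].
exists del. split; auto. intros y Oy Hy. destruct (H y Oy Hy) as [H1 H2].
replace (f y * g y - f x * g x) with ((f y - f x) * (g y - g x) + (f y - f x) * g x + f x * (g y - g x)) by ring.
eapply Rle_lt_trans; [apply Rabs_triang|].
eapply Rle_lt_trans; [apply Rplus_le_compat_r; apply Rabs_triang|].
rewrite !Rabs_mult.
pose proof (Rabs_pos (f y - f x)). pose proof (Rabs_pos (g y - g x)).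
pose proof (Rabs_pos (f x)). pose proof (Rabs_pos (g x)).
assert (Rabs (f y - f x) * Rabs (g y - g x) <= e * 1) by (apply Rmult_le_compat; lra).
assert (Rabs (f y - f x) * Rabs (g x) <= e * Rabs (g x)) by (apply Rmult_le_compat_r; lra).
assert (Rabs (f x) * Rabs (g y - g x) <= Rabs (f x) * e) by (apply Rmult_le_compat_l; lra).
unfold M in *. nra.
Qed.

Definition C1_on O f : Prop :=
  cont_on K n1 d O f /\
  forall c, inR K n1 d c = true ->
    (forall x, O x -> has_pd f x c) /\ cont_on K n1 d O (fun x => pd f x c).

Lemma C1_const O a : C1_on O (fun _ => a).
Proof.
split; [apply cont_on_const|]. intros c Hc. split.
- intros. apply pd_const.
- apply (cont_on_ext _ (fun _ => 0)); [intros; symmetry; apply pd_const|apply cont_on_const].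
Qed.

Lemma C1_plus O f g : C1_on O f -> C1_on O g -> C1_on O (fun x => f x + g x).
Proof.
intros [Cf Hf] [Cg Hg]. split; [apply cont_on_plus; auto|]. intros c Hc.
destruct (Hf c Hc) as [Pf Qf]. destruct (Hg c Hc) as [Pg Qg]. split.
- intros. apply pd_plus; auto.
- apply (cont_on_ext _ (fun x => pd f x c + pd g x c)).
  + intros. symmetry. apply pd_plus; auto.
  + apply cont_on_plus; auto.
Qed.

Lemma C1_mult O f g : C1_on O f -> C1_on O g -> C1_on O (fun x => f x * g x).
Proof.
intros [Cf Hf] [Cg Hg]. split; [apply cont_on_mult; auto|]. intros c Hc.
destruct (Hf c Hc) as [Pf Qf]. destruct (Hg c Hc) as [Pg Qg]. split.
- intros. apply pd_mult; auto.
- apply (cont_on_ext _ (fun x => pd f x c * g x + f x * pd g x c)).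
  + intros. symmetry. apply pd_mult; auto.
  + apply cont_on_plus; apply cont_on_mult; auto.
Qed.

Lemma C1_lsum O (L : list Co) (F : Co -> Pt -> R) : (forall c, In c L -> C1_on O (F c)) ->
  C1_on O (fun x => lsum L (fun c => F c x)).
Proof.
induction L; intros H; simpl.
- apply C1_const.
- apply C1_plus; [apply H; left; auto|apply IHL; intros; apply H; right; auto].
Qed.

Lemma C1_comp O f (h h' : R -> R) :
  C1_on O f ->
  (forall x, O x -> derivable_pt_lim h (f x) (h' (f x))) ->
  (forall x, O x -> continuity_pt h' (f x)) ->
  C1_on O (fun x => h (f x)).
Proof.
intros [Cf Hf] Hd Hc2.
assert (Hc1 : forall x, O x -> continuity_pt h (f x))
  by (intros x Ox; apply derivable_continuous_pt; exists (h' (f x)); exact (Hd x Ox)).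
split; [apply cont_on_comp; auto|]. intros c Hc.
destruct (Hf c Hc) as [Pf Qf]. split.
- intros. apply (proj1 (pd_comp h h' f x c (Pf x H) (Hd x H))).
- apply (cont_on_ext _ (fun x => h' (f x) * pd f x c)).
  + intros. symmetry. apply pd_comp; auto.
  + apply cont_on_mult; auto. apply cont_on_comp; auto.
Qed.

Lemma C1_exp O f : C1_on O f -> C1_on O (fun x => exp (f x)).
Proof.
intros H. apply (C1_comp _ _ exp exp); auto.
- intros. apply derivable_pt_lim_exp.
- intros. apply derivable_continuous_pt. apply derivable_pt_exp.
Qed.

Lemma C1_ln O f : C1_on O f -> (forall x, O x -> 0 < f x) -> C1_on O (fun x => ln (f x)).
Proof.
intros H Hp. apply (C1_comp _ _ ln Rinv); auto.
- intros. apply derivable_pt_lim_ln. auto.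
- intros. apply continuity_pt_inv; [apply derivable_continuous_pt, derivable_pt_id|].
  specialize (Hp x H0). unfold id; lra.
Qed.

Lemma C1_ext O f g : Vopen K n1 d O -> (forall x, O x -> supp K n1 d x) ->
  (forall x, O x -> f x = g x) -> C1_on O f -> C1_on O g.
Proof.
intros HO HS E [Cf Hf]. split; [apply (cont_on_ext _ f); auto|].
assert (Hloc : forall c, inR K n1 d c = true -> forall x, O x -> has_pd g x c /\ pd g x c = pd f x c).
{ intros c Hc x Ox. destruct (Hf c Hc) as [Pf _]. specialize (Pf x Ox).
  apply pd_spec in Pf.
  destruct (HO x Ox (HS x Ox)) as [del [Hdel Hd]].
  assert (Hnear : forall t, Rabs t < del -> f (padd x (pscale t (ebas c))) = g (padd x (pscale t (ebas c)))).
  { intros t Ht. apply E. rewrite padd_ebas_upd. apply Hd.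
    - apply supp_upd; auto.
    - intros c' Hc'. destruct (Co_eq_dec c c').
      + subst. rewrite upd_eq. replace (x c' + t - x c') with t by ring. auto.
      + rewrite upd_neq by auto. replace (x c' - x c') with 0 by ring. rewrite Rabs_R0; auto. }
  assert (Hg : derivable_pt_lim (fun t => g (padd x (pscale t (ebas c)))) 0 (pd f x c)).
  { intros eps Heps. destruct (Pf eps Heps) as [d1 Hd1].
    assert (0 < Rmin d1 del) by (apply Rmin_pos; [apply cond_pos|auto]).
    exists (mkposreal _ H). simpl. intros h Hh Hhd.
    pose proof (Rmin_l d1 del). pose proof (Rmin_r d1 del).
    rewrite <- (Hnear (0 + h)) by (replace (0 + h) with h by ring; lra).
    rewrite <- (Hnear 0) by (rewrite Rabs_R0; auto).
    apply Hd1; auto. lra. }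
  split; [eexists; eauto|apply pd_unique; auto]. }
intros c Hc. split.
- intros. apply Hloc; auto.
- apply (cont_on_ext _ (fun x => pd f x c)); [intros; symmetry; apply Hloc; auto|apply Hf; auto].
Qed.

Section ContinuousPartials.
Variables (O : Pt -> Prop) (f : Pt -> R).
Hypothesis O_open : Vopen K n1 d O.
Hypothesis pd_ex : forall c, inR K n1 d c = true -> forall y, O y -> has_pd f y c.
Hypothesis pd_cont : forall c, inR K n1 d c = true -> cont_on K n1 d O (fun y => pd f y c).

(* Change one coordinate at a time and apply the mean value theorem to each step. *)
Lemma first_order_approx x : O x -> supp K n1 d x ->
  forall eps, 0 < eps -> exists del, 0 < del /\
    forall y, supp K n1 d y -> near x y del ->
      Rabs (f y - f x - allsum K n1 d (fun c => pd f x c * (y c - x c)))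
        <= eps * allsum K n1 d (fun c => Rabs (y c - x c)).
Proof.
intros Ox Sx eps Heps.
destruct (O_open x Ox Sx) as [d0 [Hd0 HO']].
destruct (common_delta (coords K n1 d)
   (fun c del => forall y, O y -> near x y del -> Rabs (pd f y c - pd f x c) < eps))
  as [d1 [Hd1 Hd1']].
{ intros c a b Ha Hab H y Oy Hy. apply H; auto. eapply near_le; eauto. }
{ intros c Hc'. apply In_coords in Hc'.
  destruct (pd_cont c Hc' x Ox eps Heps) as [del [Hdel H]]. exists del. split; auto. }
exists (Rmin d0 d1). split; [apply Rmin_pos; auto|].
intros y Sy Hy. apply near_Rmin in Hy as [Hy0 Hy1].
rewrite <- !lsum_coords, <- (upd_list_coords x y) at 1 by auto.
pose proof (NoDup_coords K n1 d) as ND.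
assert (Hin : forall c, In c (coords K n1 d) -> inR K n1 d c = true) by (intros; apply In_coords; auto).
induction (coords K n1 d) as [|c L IH].
- simpl. replace (f x - f x - 0) with 0 by ring. rewrite Rabs_R0. lra.
- inversion ND; subst.
  specialize (IH (fun c' H => Hd1' c' (or_intror H)) H2 (fun c' H => Hin c' (or_intror H))).
  assert (Hc' : inR K n1 d c = true) by (apply Hin; left; auto).
  simpl. set (p := upd_list x y L) in *.
  assert (Hpc : p c = x c) by (apply upd_list_notin; auto).
  assert (Hstep : Rabs (f (upd p c (y c)) - f p - pd f x c * (y c - x c)) <= eps * Rabs (y c - x c)).
  { rewrite <- Hpc. apply upd_increment_bound. rewrite Hpc. intros s Hs.
    assert (Os : O (upd p c s)).
    { apply HO'; [apply supp_upd; auto; apply supp_upd_list; auto|].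
      apply near_upd_upd_list; auto. }
    split; [apply pd_ex; auto|].
    left. apply (Hd1' c (or_introl eq_refl)); auto. apply near_upd_upd_list; auto. }
  replace (f (upd p c (y c)) - f x - (pd f x c * (y c - x c) + lsum L (fun c0 => pd f x c0 * (y c0 - x c0))))
    with ((f (upd p c (y c)) - f p - pd f x c * (y c - x c)) + (f p - f x - lsum L (fun c0 => pd f x c0 * (y c0 - x c0)))) by ring.
  eapply Rle_trans; [apply Rabs_triang|]. lra.
Qed.

Lemma continuous_of_C1 x : O x -> supp K n1 d x ->
  forall eps, 0 < eps -> exists del, 0 < del /\
    forall y, supp K n1 d y -> near x y del -> Rabs (f y - f x) < eps.
Proof.
intros Ox Sx eps Heps.
destruct (first_order_approx x Ox Sx 1 Rlt_0_1) as [dF [HdF HF]].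
set (T := allsum K n1 d (fun c => Rabs (pd f x c) + 1)).
assert (HT : 0 <= T) by (apply allsum_nonneg; intros; pose proof (Rabs_pos (pd f x c)); lra).
set (del := Rmin dF (eps / (2 * T + 1))).
assert (Hdel : 0 < del) by (apply Rmin_pos; auto; apply Rdiv_lt_0_compat; lra).
exists del. split; auto. intros y Sy Hy.
specialize (HF y Sy (near_le _ _ _ _ (Rmin_l _ _) Hy)).
assert (HA : Rabs (allsum K n1 d (fun c => pd f x c * (y c - x c))) <= del * T).
{ eapply Rle_trans; [apply allsum_abs|]. unfold T. rewrite <- allsum_scal. apply allsum_le.
  intros c Hc'. rewrite Rabs_mult. specialize (Hy c Hc').
  pose proof (Rabs_pos (pd f x c)). pose proof (Rabs_pos (y c - x c)).
  assert (Rabs (pd f x c) * Rabs (y c - x c) <= Rabs (pd f x c) * del) by (apply Rmult_le_compat_l; lra).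
  lra. }
assert (HB : allsum K n1 d (fun c => Rabs (y c - x c)) <= del * T).
{ unfold T. rewrite <- allsum_scal. apply allsum_le.
  intros c Hc'. specialize (Hy c Hc'). pose proof (Rabs_pos (pd f x c)).
  assert (del * 1 <= del * (Rabs (pd f x c) + 1)) by (apply Rmult_le_compat_l; lra). lra. }
assert (Hd2 : del * (2 * T + 1) <= eps).
{ assert (del <= eps / (2 * T + 1)) by apply Rmin_r.
  apply (Rmult_le_compat_r (2 * T + 1)) in H; [|lra].
  unfold Rdiv in H. rewrite Rmult_assoc, Rinv_l in H by lra. lra. }
replace (f y - f x) with ((f y - f x - allsum K n1 d (fun c => pd f x c * (y c - x c))) + allsum K n1 d (fun c => pd f x c * (y c - x c))) by ring.
eapply Rle_lt_trans; [apply Rabs_triang|]. nra.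
Qed.

Section Path.
Variables (z : R -> Pt) (z' : Co -> R) (t0 : R).
Hypothesis z_supp : forall t, supp K n1 d (z t).
Hypothesis z_deriv : forall c, inR K n1 d c = true -> derivable_pt_lim (fun t => z t c) t0 (z' c).

Lemma path_increment_uniform e : 0 < e -> exists eta, 0 < eta /\
  forall h, h <> 0 -> Rabs h < eta -> forall c, inR K n1 d c = true ->
    Rabs (z (t0 + h) c - z t0 c - h * z' c) <= e * Rabs h.
Proof.
intros He.
destruct (common_delta (coords K n1 d)
  (fun c del => forall h, h <> 0 -> Rabs h < del -> Rabs ((z (t0 + h) c - z t0 c) / h - z' c) < e))
  as [eta [Heta H]].
{ intros c a b Ha Hab H h Hh Hhb. apply H; auto. lra. }
{ intros c Hc'. apply In_coords in Hc'. destruct (z_deriv c Hc' e He) as [del Hdel].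
  exists del. split; [apply cond_pos|]. intros h Hh Hhd. apply Hdel; auto. }
exists eta. split; auto. intros h Hh Hhe c Hc.
specialize (H c (proj2 (In_coords K n1 d c) Hc) h Hh Hhe).
replace (z (t0 + h) c - z t0 c - h * z' c) with (h * ((z (t0 + h) c - z t0 c) / h - z' c)) by (field; auto).
rewrite Rabs_mult, Rmult_comm. apply Rmult_le_compat_r; [apply Rabs_pos|lra].
Qed.

Lemma path_increment_le h e : e <= 1 ->
  (forall c, inR K n1 d c = true -> Rabs (z (t0 + h) c - z t0 c - h * z' c) <= e * Rabs h) ->
  forall c, inR K n1 d c = true -> Rabs (z (t0 + h) c - z t0 c) <= Rabs h * (Rabs (z' c) + 1).
Proof.
intros He Hz c Hc. specialize (Hz c Hc).
pose proof (Rabs_triang_inv (z (t0 + h) c - z t0 c) (h * z' c)) as T.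
rewrite Rabs_mult in T. pose proof (Rabs_pos h). nra.
Qed.

Lemma linearization_split h : h <> 0 ->
  (f (z (t0 + h)) - f (z t0)) / h - allsum K n1 d (fun c => pd f (z t0) c * z' c)
  = (f (z (t0 + h)) - f (z t0) - allsum K n1 d (fun c => pd f (z t0) c * (z (t0 + h) c - z t0 c))
     + allsum K n1 d (fun c => pd f (z t0) c * (z (t0 + h) c - z t0 c - h * z' c))) / h.
Proof.
intros Hh.
rewrite (allsum_ext K n1 d (fun c => pd f (z t0) c * (z (t0 + h) c - z t0 c - h * z' c))
  (fun c => pd f (z t0) c * (z (t0 + h) c - z t0 c) - h * (pd f (z t0) c * z' c))) by (intros; ring).
rewrite allsum_minus, allsum_scal. field. auto.
Qed.

Lemma chain_rule : O (z t0) ->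
  derivable_pt_lim (fun t => f (z t)) t0 (allsum K n1 d (fun c => pd f (z t0) c * z' c)).
Proof.
intros Ox eps Heps.
set (S1 := allsum K n1 d (fun c => Rabs (z' c) + 1)).
set (S2 := allsum K n1 d (fun c => Rabs (pd f (z t0) c))).
assert (HS1 : 0 <= S1) by (apply allsum_nonneg; intros; pose proof (Rabs_pos (z' c)); lra).
assert (HS2 : 0 <= S2) by (apply allsum_nonneg; intros; apply Rabs_pos).
set (e1 := eps / (2 * (S1 + 1))).
set (e2 := Rmin 1 (eps / (2 * (S2 + 1)))).
assert (He1 : e1 * (S1 + 1) = eps / 2) by (unfold e1; field; lra).
assert (He2 : 0 < e2) by (apply Rmin_pos; [lra|apply Rdiv_lt_0_compat; lra]).
assert (He2S : e2 * (S2 + 1) <= eps / 2).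
{ assert (e2 <= eps / (2 * (S2 + 1))) by apply Rmin_r.
  assert (eps / (2 * (S2 + 1)) * (S2 + 1) = eps / 2) by (field; lra). nra. }
destruct (first_order_approx (z t0) Ox (z_supp t0) e1) as [dF [HdF HF]]; [nra|].
destruct (path_increment_uniform e2 He2) as [eta [Heta Hz]].
assert (Hd3 : 0 < dF / (S1 + 1)) by (apply Rdiv_lt_0_compat; lra).
exists (mkposreal _ (Rmin_pos _ _ Heta Hd3)). simpl. intros h Hh Hhd.
pose proof (Rmin_l eta (dF / (S1 + 1))). pose proof (Rmin_r eta (dF / (S1 + 1))).
assert (Hah : 0 < Rabs h) by (apply Rabs_pos_lt; auto).
assert (HhF : Rabs h * (S1 + 1) < dF).
{ assert (Rabs h < dF / (S1 + 1)) by lra.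
  apply (Rmult_lt_compat_r (S1 + 1)) in H1; [|lra]. unfold Rdiv in H1.
  rewrite Rmult_assoc, Rinv_l in H1 by lra. lra. }
specialize (Hz h Hh ltac:(lra)).
pose proof (path_increment_le h e2 (Rmin_l _ _) Hz) as Hhz.
assert (Hnear : near (z t0) (z (t0 + h)) dF).
{ intros c Hc. eapply Rle_lt_trans; [apply Hhz; auto|].
  assert (Rabs (z' c) + 1 <= S1).
  { apply (allsum_ge_term K n1 d (fun c => Rabs (z' c) + 1)); auto.
    intros c0 _. pose proof (Rabs_pos (z' c0)). lra. }
  nra. }
specialize (HF (z (t0 + h)) (z_supp _) Hnear).
rewrite linearization_split by auto.
apply Rabs_div_lt; auto.
assert (HA : Rabs (f (z (t0 + h)) - f (z t0) - allsum K n1 d (fun c => pd f (z t0) c * (z (t0 + h) c - z t0 c)))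
             <= e1 * (Rabs h * S1)).
{ eapply Rle_trans; [apply HF|]. apply Rmult_le_compat_l; [unfold e1; apply Rlt_le, Rdiv_lt_0_compat; lra|].
  unfold S1. rewrite <- allsum_scal. apply allsum_le. intros c Hc. apply Hhz; auto. }
assert (HB : Rabs (allsum K n1 d (fun c => pd f (z t0) c * (z (t0 + h) c - z t0 c - h * z' c)))
             <= (e2 * Rabs h) * S2).
{ eapply Rle_trans; [apply allsum_abs|]. unfold S2. rewrite <- allsum_scal.
  apply allsum_le. intros c Hc. rewrite Rabs_mult, (Rmult_comm (e2 * Rabs h)).
  apply Rmult_le_compat_l; [apply Rabs_pos|]. apply Hz; auto. }
assert (0 < e1) by (unfold e1; apply Rdiv_lt_0_compat; lra).
assert (e1 * (Rabs h * S1) < eps / 2 * Rabs h) by nra.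
assert (e2 * Rabs h * S2 < eps / 2 * Rabs h) by nra.
eapply Rle_lt_trans; [apply Rabs_triang|]. lra.
Qed.

End Path.
End ContinuousPartials.
End Calculus.

(** * Powers, Young's inequality and [l^p] norms *)

Lemma powp_pos_eq x q : 0 < x -> powp x q = Rpower x q.
Proof. intros. unfold powp. destruct (Rle_lt_dec x 0); [lra|auto]. Qed.

Lemma powp_nonpos x q : x <= 0 -> powp x q = 0.
Proof. intros. unfold powp. destruct (Rle_lt_dec x 0); [auto|lra]. Qed.

Lemma Rpower_pos x q : 0 < Rpower x q.
Proof. unfold Rpower. apply exp_pos. Qed.

Lemma powp_nonneg x q : 0 <= powp x q.
Proof. unfold powp. destruct (Rle_lt_dec x 0); [lra|left; apply Rpower_pos]. Qed.

Lemma powp_pos x q : 0 < x -> 0 < powp x q.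
Proof. intros. rewrite powp_pos_eq; auto. apply Rpower_pos. Qed.

Lemma exp_convex th a b : 0 <= th <= 1 ->
  exp (th * a + (1 - th) * b) <= th * exp a + (1 - th) * exp b.
Proof.
intros Hth. set (m := th * a + (1 - th) * b).
assert (Ha : exp a = exp m * exp (a - m)) by (rewrite <- exp_plus; f_equal; ring).
assert (Hb : exp b = exp m * exp (b - m)) by (rewrite <- exp_plus; f_equal; ring).
pose proof (exp_ineq1_le (a - m)). pose proof (exp_ineq1_le (b - m)). pose proof (exp_pos m).
rewrite Ha, Hb.
assert (th * exp (a - m) + (1 - th) * exp (b - m) >= 1).
{ assert (th * (1 + (a - m)) + (1 - th) * (1 + (b - m)) = 1) by (unfold m; ring). nra. }
nra.
Qed.

Lemma exp_convex_strict th a b : 0 < th < 1 -> a <> b ->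
  exp (th * a + (1 - th) * b) < th * exp a + (1 - th) * exp b.
Proof.
intros Hth Hab. set (m := th * a + (1 - th) * b).
assert (Ha : exp a = exp m * exp (a - m)) by (rewrite <- exp_plus; f_equal; ring).
assert (Hb : exp b = exp m * exp (b - m)) by (rewrite <- exp_plus; f_equal; ring).
assert (a - m <> 0) by (unfold m; intro; apply Hab; nra).
pose proof (exp_ineq1 (a - m) H). pose proof (exp_ineq1_le (b - m)). pose proof (exp_pos m).
rewrite Ha, Hb.
assert (th * exp (a - m) + (1 - th) * exp (b - m) > 1).
{ assert (th * (1 + (a - m)) + (1 - th) * (1 + (b - m)) = 1) by (unfold m; ring). nra. }
nra.
Qed.

Lemma conjexp_facts p : 1 < p ->
  1 < conjexp p /\ / p + / conjexp p = 1 /\ (conjexp p - 1) * p = conjexp p /\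
  conjexp p - 1 = / (p - 1) /\ conjexp p / p = conjexp p - 1.
Proof.
intros Hp. unfold conjexp. repeat split.
- apply (Rmult_lt_reg_r (p - 1)); [lra|]. unfold Rdiv. rewrite Rmult_assoc, Rinv_l by lra. lra.
- field. lra.
- field. lra.
- field. lra.
- field. lra.
Qed.

Lemma conjexp_mul p : 1 < p -> (p - 1) * (conjexp p - 1) = 1.
Proof. intros. unfold conjexp. field. lra. Qed.

Lemma Rpower_base_1 e : Rpower 1 e = 1.
Proof. unfold Rpower. rewrite ln_1, Rmult_0_r. apply exp_0. Qed.

Lemma young a b p : 0 <= a -> 0 <= b -> 1 < p ->
  a * b <= powp a p / p + powp b (conjexp p) / conjexp p.
Proof.
intros Ha Hb Hp. destruct (conjexp_facts p Hp) as [Hq [Hs _]].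
set (q := conjexp p) in *.
pose proof (powp_nonneg a p). pose proof (powp_nonneg b q).
assert (0 < / p) by (apply Rinv_0_lt_compat; lra).
assert (0 < / q) by (apply Rinv_0_lt_compat; lra).
destruct Ha as [Ha|Ha]; [|subst; unfold Rdiv; nra].
destruct Hb as [Hb|Hb]; [|subst; unfold Rdiv; nra].
rewrite !powp_pos_eq by auto. unfold Rpower.
replace (a * b) with (exp (/ p * (p * ln a) + (1 - / p) * (q * ln b))).
- replace (1 - / p) with (/ q) by lra. unfold Rdiv. rewrite (Rmult_comm (exp _) (/ p)), (Rmult_comm (exp (q * _)) (/ q)).
  pose proof (exp_convex (/ p) (p * ln a) (q * ln b)). replace (1 - / p) with (/ q) in H3 by lra.
  apply H3. split; [lra|]. lra.
- replace (/ p * (p * ln a) + (1 - / p) * (q * ln b)) with (ln a + ln b).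
  + rewrite exp_plus, !exp_ln; auto.
  + replace (1 - / p) with (/ q) by lra. field. split; lra.
Qed.

Lemma young_strict a b p : 0 <= a -> 0 < b -> 1 < p -> powp a p <> powp b (conjexp p) ->
  a * b < powp a p / p + powp b (conjexp p) / conjexp p.
Proof.
intros Ha Hb Hp Hne. destruct (conjexp_facts p Hp) as [Hq [Hs _]].
set (q := conjexp p) in *.
pose proof (powp_nonneg a p). pose proof (powp_pos b q Hb).
assert (0 < / p) by (apply Rinv_0_lt_compat; lra).
assert (0 < / q) by (apply Rinv_0_lt_compat; lra).
destruct Ha as [Ha|Ha]; [|subst; unfold Rdiv; nra].
rewrite !powp_pos_eq in * by auto. unfold Rpower in *.
replace (a * b) with (exp (/ p * (p * ln a) + (1 - / p) * (q * ln b))).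
- unfold Rdiv. rewrite (Rmult_comm (exp _) (/ p)), (Rmult_comm (exp (q * _)) (/ q)).
  pose proof (exp_convex_strict (/ p) (p * ln a) (q * ln b)). replace (1 - / p) with (/ q) in * by lra.
  apply H3; [split; [lra|]; lra|]. intro E; apply Hne; rewrite E; auto.
- replace (/ p * (p * ln a) + (1 - / p) * (q * ln b)) with (ln a + ln b).
  + rewrite exp_plus, !exp_ln; auto.
  + replace (1 - / p) with (/ q) by lra. field. split; lra.
Qed.

(* Young's inequality with [b = c^(p-1)]. *)
Lemma powp_tangent_line a c p : 0 <= a -> 0 < c -> 1 < p ->
  powp c p + p * powp c (p - 1) * (a - c) <= powp a p.
Proof.
intros Ha Hc Hp. destruct (conjexp_facts p Hp) as [Hq [Hs _]].
pose proof (young a (powp c (p - 1)) p Ha (powp_nonneg _ _) Hp) as Y.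
assert (E : powp (powp c (p - 1)) (conjexp p) = powp c p).
{ rewrite (powp_pos_eq c (p - 1)) by auto. rewrite powp_pos_eq by apply Rpower_pos.
  rewrite (powp_pos_eq c p) by auto. rewrite Rpower_mult. f_equal.
  unfold conjexp. field. lra. }
rewrite E in Y.
assert (Ec : powp c p = c * powp c (p - 1)).
{ rewrite !powp_pos_eq by auto. replace p with (1 + (p - 1)) at 1 by ring.
  rewrite Rpower_plus, Rpower_1; auto. }
assert (/ conjexp p = 1 - / p) by lra.
unfold Rdiv in Y. rewrite H in Y.
apply (Rmult_le_compat_l p) in Y; [|lra].
replace (p * (powp a p * / p + powp c p * (1 - / p))) with (powp a p + (p - 1) * powp c p) in Y by (field; lra).
rewrite Ec in *. nra.
Qed.

Lemma powp_convex a b t p : 0 <= a -> 0 <= b -> 0 <= t <= 1 -> 1 < p ->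
  powp ((1 - t) * a + t * b) p <= (1 - t) * powp a p + t * powp b p.
Proof.
intros Ha Hb Ht Hp.
set (c := (1 - t) * a + t * b).
assert (Hc : 0 <= c) by (unfold c; nra).
destruct Hc as [Hc|Hc].
2:{ rewrite <- Hc, powp_nonpos by lra. pose proof (powp_nonneg a p). pose proof (powp_nonneg b p). nra. }
pose proof (powp_tangent_line a c p Ha Hc Hp) as T1.
pose proof (powp_tangent_line b c p Hb Hc Hp) as T2.
set (P := powp c p) in *. set (k := p * powp c (p - 1)) in *.
assert ((1 - t) * (P + k * (a - c)) <= (1 - t) * powp a p) by (apply Rmult_le_compat_l; lra).
assert (t * (P + k * (b - c)) <= t * powp b p) by (apply Rmult_le_compat_l; lra).
assert ((1 - t) * (P + k * (a - c)) + t * (P + k * (b - c)) = P) by (unfold c; ring).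
lra.
Qed.

Definition psum (p : R) (x : Pt) (L : list Co) : R := lsum L (fun c => powp (Rabs (x c)) p).
Definition lpnorm (p : R) (x : Pt) (L : list Co) : R := powp (psum p x L) (1 / p).
Definition row_coords (n1 i : nat) : list Co := map (CW i) (seq 0 n1).
Definition u_coords (n1 d : nat) : list Co := flat_map (fun a => map (CU a) (seq 0 d)) (seq 0 n1).

Lemma rownorm_lpnorm n1 p x i : rownorm n1 p x i = lpnorm p x (row_coords n1 i).
Proof. unfold rownorm, lpnorm, psum, row_coords. rewrite lsum_map_seq. reflexivity. Qed.

Lemma unorm_lpnorm n1 d p x : unorm n1 d p x = lpnorm p x (u_coords n1 d).
Proof.
unfold unorm, lpnorm, psum, u_coords. rewrite lsum_flat_map_seq. f_equal.
apply rsum_ext. intros. rewrite lsum_map_seq. reflexivity.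
Qed.

Lemma psum_nonneg p x L : 0 <= psum p x L.
Proof. apply lsum_nonneg. intros. apply powp_nonneg. Qed.

Lemma lpnorm_nonneg p x L : 0 <= lpnorm p x L.
Proof. apply powp_nonneg. Qed.

Lemma Rpower_inv_le S rho p : 0 < S -> 0 < rho -> 1 < p ->
  (Rpower S (1 / p) <= rho <-> S <= Rpower rho p).
Proof.
intros HS Hr Hp. unfold Rpower.
rewrite <- (exp_ln rho) at 1 by auto. rewrite <- (exp_ln S) at 2 by auto.
split; intro H.
- destruct H as [H|H].
  + apply exp_lt_inv in H. left. apply exp_increasing.
    apply (Rmult_lt_compat_l p) in H; [|lra]. unfold Rdiv in H.
    replace (p * (1 * / p * ln S)) with (ln S) in H by (field; lra). lra.
  + apply exp_inv in H. right. f_equal. rewrite <- H. field. lra.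
- destruct H as [H|H].
  + apply exp_lt_inv in H. left. apply exp_increasing.
    apply (Rmult_lt_compat_l (/ p)) in H; [|apply Rinv_0_lt_compat; lra].
    replace (/ p * (p * ln rho)) with (ln rho) in H by (field; lra). lra.
  + apply exp_inv in H. right. f_equal. rewrite H. field. lra.
Qed.

Lemma Rpower_inv_eq S rho p : 0 < S -> 0 < rho -> 1 < p ->
  (Rpower S (1 / p) = rho <-> S = Rpower rho p).
Proof.
intros HS Hr Hp. split; intro H.
- subst rho. rewrite Rpower_mult. replace (1 / p * p) with 1 by (field; lra). rewrite Rpower_1; auto.
- subst S. unfold Rpower. rewrite ln_exp. unfold Rdiv.
  replace (1 * / p * (p * ln rho)) with (ln rho) by (field; lra). apply exp_ln; auto.
Qed.

Lemma lpnorm_le p x L rho : 1 < p -> 0 < rho -> (lpnorm p x L <= rho <-> psum p x L <= Rpower rho p).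
Proof.
intros Hp Hr. unfold lpnorm. destruct (psum_nonneg p x L) as [H|H].
- rewrite powp_pos_eq by auto. apply Rpower_inv_le; auto.
- rewrite <- H, powp_nonpos by lra. pose proof (Rpower_pos rho p). split; intros; lra.
Qed.

Lemma lpnorm_eq p x L rho : 1 < p -> 0 < rho -> (lpnorm p x L = rho <-> psum p x L = Rpower rho p).
Proof.
intros Hp Hr. unfold lpnorm. destruct (psum_nonneg p x L) as [H|H].
- rewrite powp_pos_eq by auto. apply Rpower_inv_eq; auto.
- rewrite <- H, powp_nonpos by lra. pose proof (Rpower_pos rho p). split; intros; lra.
Qed.

Lemma powp_scale a s p : 0 < a -> 0 <= s -> powp (a * s) p = Rpower a p * powp s p.
Proof.
intros Ha [Hs|Hs].
- rewrite !powp_pos_eq by (auto; nra). rewrite Rpower_mult_distr; auto.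
- subst. rewrite Rmult_0_r, powp_nonpos by lra. ring.
Qed.

Lemma psum_scale p x L a : 0 < a -> psum p (fun c => a * x c) L = Rpower a p * psum p x L.
Proof.
intros Ha. unfold psum. rewrite <- lsum_scal. apply lsum_ext. intros.
rewrite Rabs_mult, (Rabs_right a) by lra. apply powp_scale; auto. apply Rabs_pos.
Qed.

Lemma lpnorm_scale p x L a : 1 < p -> 0 < a -> lpnorm p (fun c => a * x c) L = a * lpnorm p x L.
Proof.
intros Hp Ha. unfold lpnorm. rewrite psum_scale by auto.
rewrite powp_scale; [|apply Rpower_pos|apply psum_nonneg].
f_equal. rewrite Rpower_mult. replace (p * (1 / p)) with 1 by (field; lra). apply Rpower_1; auto.
Qed.

Lemma abs_le_lpnorm p x L c : 1 < p -> In c L -> Rabs (x c) <= lpnorm p x L.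
Proof.
intros Hp Hc.
destruct (Rabs_pos (x c)) as [H|H]; [|rewrite <- H; apply lpnorm_nonneg].
assert (Hle : powp (Rabs (x c)) p <= psum p x L).
{ apply (lsum_ge_term L (fun c => powp (Rabs (x c)) p)); auto. intros; apply powp_nonneg. }
assert (0 < powp (Rabs (x c)) p) by (apply powp_pos; auto).
unfold lpnorm. rewrite powp_pos_eq by lra.
rewrite powp_pos_eq in * by auto.
replace (Rabs (x c)) with (Rpower (Rpower (Rabs (x c)) p) (1 / p)).
- apply Rle_Rpower_l; [apply Rlt_le; apply Rdiv_lt_0_compat; lra|]. split; auto.
- rewrite Rpower_mult. replace (p * (1 / p)) with 1 by (field; lra). apply Rpower_1; auto.
Qed.

Lemma psum_ext p x y L : (forall c, In c L -> x c = y c) -> psum p x L = psum p y L.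
Proof. intros. unfold psum. apply lsum_ext. intros. rewrite H; auto. Qed.

Lemma lpnorm_ext p x y L : (forall c, In c L -> x c = y c) -> lpnorm p x L = lpnorm p y L.
Proof. intros. unfold lpnorm. rewrite (psum_ext p x y L); auto. Qed.

Lemma psum_pos p x L c : In c L -> 0 < x c -> 0 < psum p x L.
Proof.
intros Hin Hx. unfold psum. eapply Rlt_le_trans; [|apply (lsum_ge_term _ _ c); auto; intros; apply powp_nonneg].
apply powp_pos. rewrite Rabs_right; lra.
Qed.

Lemma lpnorm_pos p x L c : In c L -> 0 < x c -> 0 < lpnorm p x L.
Proof. intros. unfold lpnorm. apply powp_pos. eapply psum_pos; eauto. Qed.

(** * Blocks of coordinates and the map [G^Phi] *)

(* Block [b < K] is the row [w_b], with exponent [pw] and radius [rw]; block [K] is [u],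
   with exponent [pu] and radius [ru]. *)
Definition blk_exp (K : nat) (pw pu : R) (b : nat) : R := if Nat.ltb b K then pw else pu.
Definition blk_radius (K : nat) (rw ru : R) (b : nat) : R := if Nat.ltb b K then rw else ru.
Definition blk_coords (K n1 d : nat) (b : nat) : list Co := if Nat.ltb b K then row_coords n1 b else u_coords n1 d.

Lemma blk_exp_gt1 K pw pu b : 1 < pw -> 1 < pu -> 1 < blk_exp K pw pu b.
Proof. unfold blk_exp. destruct (Nat.ltb b K); auto. Qed.

Lemma blk_radius_pos K rw ru b : 0 < rw -> 0 < ru -> 0 < blk_radius K rw ru b.
Proof. unfold blk_radius. destruct (Nat.ltb b K); auto. Qed.

Lemma In_row_coords n1 i c : In c (row_coords n1 i) <-> exists j, c = CW i j /\ (j < n1)%nat.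
Proof.
unfold row_coords. rewrite in_map_iff. split.
- intros [j [Hj Hin]]. exists j. apply in_seq in Hin. split; auto; lia.
- intros [j [Hj Hlt]]. exists j. split; auto. apply in_seq. lia.
Qed.

Lemma In_u_coords n1 d c : In c (u_coords n1 d) <-> exists a b, c = CU a b /\ (a < n1)%nat /\ (b < d)%nat.
Proof.
unfold u_coords. rewrite in_flat_map. split.
- intros [a [Ha Hin]]. apply in_map_iff in Hin. destruct Hin as [b [Hb Hin]].
  apply in_seq in Ha, Hin. exists a, b. repeat split; auto; lia.
- intros [a [b [Hc [Ha Hb]]]]. exists a. split; [apply in_seq; lia|]. apply in_map_iff. exists b. split; auto. apply in_seq. lia.
Qed.

Lemma In_blk_coords K n1 d b c : (b <= K)%nat -> In c (blk_coords K n1 d b) <-> (inR K n1 d c = true /\ blk K c = b).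
Proof.
intros Hb. unfold blk_coords. destruct (Nat.ltb b K) eqn:E.
- apply Nat.ltb_lt in E. rewrite In_row_coords. split.
  + intros [j [Hc Hj]]. subst. simpl. rewrite andb_true_iff, !Nat.ltb_lt. auto.
  + intros [Hc Hbk]. destruct c; simpl in *; [|lia]. rewrite andb_true_iff, !Nat.ltb_lt in Hc. subst.
    exists j. split; auto; lia.
- apply Nat.ltb_ge in E. assert (b = K) by lia. subst. rewrite In_u_coords. split.
  + intros [a [b0 [Hc [Ha Hb0]]]]. subst. simpl. rewrite andb_true_iff, !Nat.ltb_lt. auto.
  + intros [Hc Hbk]. destruct c; simpl in *.
    * rewrite andb_true_iff, !Nat.ltb_lt in Hc. lia.
    * rewrite andb_true_iff, !Nat.ltb_lt in Hc. exists a, b. repeat split; lia.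
Qed.

Lemma blk_le K n1 d c : inR K n1 d c = true -> (blk K c <= K)%nat.
Proof. destruct c; simpl; rewrite andb_true_iff, !Nat.ltb_lt; lia. Qed.

Lemma In_blk_coords_self K n1 d c : inR K n1 d c = true -> In c (blk_coords K n1 d (blk K c)).
Proof. intros H. apply In_blk_coords; auto. apply blk_le with n1 d; auto. Qed.

Lemma blk_coords_nonempty K n1 d b : (1 <= n1)%nat -> (1 <= d)%nat -> (b <= K)%nat ->
  exists c, In c (blk_coords K n1 d b).
Proof.
intros. unfold blk_coords. destruct (Nat.ltb b K) eqn:E.
- exists (CW b 0). apply In_row_coords. exists 0%nat. split; auto; lia.
- exists (CU 0 0). apply In_u_coords. exists 0%nat, 0%nat. repeat split; lia.
Qed.

Lemma psi_pos q g : 0 < g -> psi q g = Rpower g (q - 1).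
Proof. intros. unfold psi. destruct (Rlt_dec g 0); [lra|]. apply powp_pos_eq; auto. Qed.

Lemma Gmap_blk_formula K n1 d pw pu rw ru Phi x c : inR K n1 d c = true ->
  Gmap K n1 d pw pu rw ru Phi x c =
  blk_radius K rw ru (blk K c) *
  psi (conjexp (blk_exp K pw pu (blk K c))) (grad K n1 d Phi x c) /
  lpnorm (blk_exp K pw pu (blk K c)) (fun c' => psi (conjexp (blk_exp K pw pu (blk K c))) (grad K n1 d Phi x c')) (blk_coords K n1 d (blk K c)).
Proof.
intros Hc. unfold Gmap. rewrite Hc. unfold blk_exp, blk_radius, blk_coords.
destruct c; simpl in *; rewrite andb_true_iff, !Nat.ltb_lt in Hc.
- assert (E : Nat.ltb i K = true) by (apply Nat.ltb_lt; lia). rewrite E. rewrite rownorm_lpnorm. auto.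
- rewrite Nat.ltb_irrefl. rewrite unorm_lpnorm. auto.
Qed.

Lemma Gmap_on_blk K n1 d pw pu rw ru Phi x b c :
  (b <= K)%nat -> In c (blk_coords K n1 d b) ->
  (forall c, inR K n1 d c = true -> 0 < pd Phi x c) ->
  Gmap K n1 d pw pu rw ru Phi x c =
  blk_radius K rw ru b * Rpower (pd Phi x c) (conjexp (blk_exp K pw pu b) - 1) /
  lpnorm (blk_exp K pw pu b) (fun c' => Rpower (pd Phi x c') (conjexp (blk_exp K pw pu b) - 1)) (blk_coords K n1 d b).
Proof.
intros Hb Hin Hg. pose proof Hin as Hin'. apply In_blk_coords in Hin'; auto. destruct Hin' as [Hc Hbc].
rewrite Gmap_blk_formula by auto. rewrite Hbc. unfold grad at 1. rewrite Hc, psi_pos by auto.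
f_equal. apply lpnorm_ext. intros c' Hc'. apply In_blk_coords in Hc'; auto. destruct Hc' as [Hc' _].
unfold grad. rewrite Hc', psi_pos by auto. auto.
Qed.

Lemma blk_norms K n1 d pw pu x :
  (forall i, (i < K)%nat -> rownorm n1 pw x i = lpnorm pw x (blk_coords K n1 d i)) /\
  unorm n1 d pu x = lpnorm pu x (blk_coords K n1 d K).
Proof.
split.
- intros i Hi. unfold blk_coords. replace (Nat.ltb i K) with true by (symmetry; apply Nat.ltb_lt; auto).
  apply rownorm_lpnorm.
- unfold blk_coords. rewrite Nat.ltb_irrefl. apply unorm_lpnorm.
Qed.

Section PositiveGradient.
Variables (K n1 d : nat) (pw pu rw ru : R) (Phi : Pt -> R) (x : Pt).
Hypotheses (Hn1 : (1 <= n1)%nat) (Hd : (1 <= d)%nat) (Hpw : 1 < pw) (Hpu : 1 < pu)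
  (Hrw : 0 < rw) (Hru : 0 < ru).
Hypothesis grad_pos : forall c, inR K n1 d c = true -> 0 < pd Phi x c.

Lemma dual_lpnorm_pos b : (b <= K)%nat ->
  0 < lpnorm (blk_exp K pw pu b) (fun c' => Rpower (pd Phi x c') (conjexp (blk_exp K pw pu b) - 1))
        (blk_coords K n1 d b).
Proof.
intros Hb. destruct (blk_coords_nonempty K n1 d b Hn1 Hd Hb) as [c0 Hc0].
apply (lpnorm_pos _ _ _ c0); auto. apply Rpower_pos.
Qed.

Lemma Gmap_pos c : inR K n1 d c = true -> 0 < Gmap K n1 d pw pu rw ru Phi x c.
Proof.
intros Hc. pose proof (blk_le K n1 d c Hc) as Hb.
rewrite (Gmap_on_blk K n1 d pw pu rw ru Phi x (blk K c)) by auto using In_blk_coords_self.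
apply Rdiv_lt_0_compat; [apply Rmult_lt_0_compat; [apply blk_radius_pos|apply Rpower_pos]|]; auto.
apply dual_lpnorm_pos; auto.
Qed.

Lemma Gmap_blk_norm b : (b <= K)%nat ->
  lpnorm (blk_exp K pw pu b) (Gmap K n1 d pw pu rw ru Phi x) (blk_coords K n1 d b) = blk_radius K rw ru b.
Proof.
intros Hb.
set (p := blk_exp K pw pu b).
set (a := fun c' => Rpower (pd Phi x c') (conjexp p - 1)).
set (N := lpnorm p a (blk_coords K n1 d b)).
assert (HN : 0 < N) by apply dual_lpnorm_pos, Hb.
pose proof (blk_radius_pos K rw ru b Hrw Hru).
assert (Hp : 1 < p) by (apply blk_exp_gt1; auto).
rewrite (lpnorm_ext _ _ (fun c => (blk_radius K rw ru b / N) * a c)).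
- rewrite lpnorm_scale by (auto; apply Rdiv_lt_0_compat; auto). fold N. field. lra.
- intros c Hin. rewrite (Gmap_on_blk K n1 d pw pu rw ru Phi x b) by auto. unfold N, a, p, Rdiv. ring.
Qed.

Lemma Gmap_S_pp : S_pp K n1 d pw pu rw ru (Gmap K n1 d pw pu rw ru Phi x).
Proof.
destruct (blk_norms K n1 d pw pu (Gmap K n1 d pw pu rw ru Phi x)) as [Hrow Hu].
split; [repeat split|intros; apply Gmap_pos; auto].
- intros c Hc. unfold Gmap. rewrite Hc. auto.
- intros c Hc. left. apply Gmap_pos; auto.
- rewrite Hu. pose proof (Gmap_blk_norm K (le_n K)) as E.
  unfold blk_exp, blk_radius in E. rewrite Nat.ltb_irrefl in E. auto.
- intros i Hi. rewrite Hrow by auto.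
  pose proof (Gmap_blk_norm i (Nat.lt_le_incl _ _ Hi)) as E.
  unfold blk_exp, blk_radius in E. replace (Nat.ltb i K) with true in E by (symmetry; apply Nat.ltb_lt; auto). auto.
Qed.

End PositiveGradient.

Definition pos_grad_region (K n1 d : nat) (U : Pt -> Prop) (Phi : Pt -> R) (x : Pt) : Prop :=
  U x /\ supp K n1 d x /\ forall c, inR K n1 d c = true -> 0 < pd Phi x c.

Lemma pos_grad_region_open K n1 d U Phi : Vopen K n1 d U ->
  (forall c, inR K n1 d c = true -> cont_on K n1 d U (fun x => pd Phi x c)) ->
  Vopen K n1 d (pos_grad_region K n1 d U Phi).
Proof.
intros HU Hc x [Ux [Sx Px]] _.
destruct (HU x Ux Sx) as [d0 [Hd0 H0]].
destruct (common_delta (coords K n1 d)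
  (fun c del => forall y, U y -> near K n1 d x y del -> Rabs (pd Phi y c - pd Phi x c) < pd Phi x c))
  as [d1 [Hd1 H1]].
{ intros c a b Ha Hab H y Uy Hy. apply H; auto. eapply near_le; eauto. }
{ intros c Hin. apply In_coords in Hin. destruct (Hc c Hin x Ux (pd Phi x c) (Px c Hin)) as [del [Hdel H']].
  exists del. split; auto. }
exists (Rmin d0 d1). split; [apply Rmin_pos; auto|].
intros y Sy Hy. apply near_Rmin in Hy as [nb0 nb1].
assert (Uy : U y) by (apply H0; auto).
split; [auto|split; [auto|]].
intros c Hc'. assert (In c (coords K n1 d)) by (apply In_coords; auto).
specialize (H1 c H y Uy nb1). apply Rabs_def2 in H1. lra.
Qed.

Definition C2_open (K n1 d : nat) (U : Pt -> Prop) (Phi : Pt -> R) : Prop :=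
  Vopen K n1 d U /\ C2_on K n1 d U Phi.

Lemma C1_pd K n1 d U Phi c : C2_open K n1 d U Phi -> inR K n1 d c = true ->
  C1_on K n1 d (pos_grad_region K n1 d U Phi) (fun x => pd Phi x c).
Proof.
intros [HU HC] Hc. destruct (HC c Hc) as [_ [Hcont Hsec]].
split.
- apply (cont_on_sub _ _ _ U); [intros x [Ux _]; auto|auto].
- intros c' Hc'. destruct (Hsec c' Hc') as [P Q]. split.
  + intros x [Ux _]. auto.
  + apply (cont_on_sub _ _ _ U); [intros x [Ux _]; auto|auto].
Qed.

(* Written with [exp], [ln] and sums of partial derivatives, [G^Phi] is visibly [C^1]. *)
Lemma Gmap_exp_form K n1 d pw pu rw ru U Phi c x :
  (1 <= n1)%nat -> (1 <= d)%nat -> inR K n1 d c = true -> pos_grad_region K n1 d U Phi x ->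
  let b := blk K c in let p := blk_exp K pw pu b in let q := conjexp p in
  Gmap K n1 d pw pu rw ru Phi x c =
  blk_radius K rw ru b * exp ((q - 1) * ln (pd Phi x c)) *
  exp (- (1 / p) * ln (lsum (blk_coords K n1 d b) (fun c' => exp (p * ((q - 1) * ln (pd Phi x c')))))).
Proof.
intros Hn1 Hd Hc [Ux [Sx Px]] b p q.
assert (Hb : (b <= K)%nat) by (apply blk_le with n1 d; auto).
rewrite (Gmap_on_blk K n1 d pw pu rw ru Phi x b) by (auto using In_blk_coords_self).
fold p q. unfold Rdiv, Rpower at 1. f_equal.
unfold lpnorm, psum.
rewrite (lsum_ext _ _ (fun c' => exp (p * ((q - 1) * ln (pd Phi x c'))))).
2:{ intros c' Hin. apply In_blk_coords in Hin as [Hin _]; auto.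
    rewrite Rabs_right by (left; apply Rpower_pos). rewrite powp_pos_eq by apply Rpower_pos.
    unfold Rpower. rewrite ln_exp. auto. }
destruct (blk_coords_nonempty K n1 d b Hn1 Hd Hb) as [c0 Hc0].
rewrite powp_pos_eq.
- unfold Rpower. rewrite <- exp_Ropp. f_equal. unfold Rdiv. ring.
- eapply Rlt_le_trans; [|apply (lsum_ge_term _ _ c0); auto; intros; left; apply exp_pos]. apply exp_pos.
Qed.

Lemma Gmap_C1 K n1 d pw pu rw ru U Phi c :
  (1 <= n1)%nat -> (1 <= d)%nat -> C2_open K n1 d U Phi -> inR K n1 d c = true ->
  C1_on K n1 d (pos_grad_region K n1 d U Phi) (fun x => Gmap K n1 d pw pu rw ru Phi x c).
Proof.
intros Hn1 Hd HC Hc.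
set (b := blk K c). set (p := blk_exp K pw pu b). set (q := conjexp p).
assert (Hb : (b <= K)%nat) by (apply blk_le with n1 d; auto).
assert (HlnC1 : forall c', inR K n1 d c' = true ->
  C1_on K n1 d (pos_grad_region K n1 d U Phi) (fun x => ln (pd Phi x c'))).
{ intros c' Hc'. apply C1_ln; [apply C1_pd; auto|]. intros x [_ [_ Px]]; auto. }
apply (C1_ext _ _ _ _ (fun x => blk_radius K rw ru b * exp ((q - 1) * ln (pd Phi x c)) *
  exp (- (1 / p) * ln (lsum (blk_coords K n1 d b) (fun c' => exp (p * ((q - 1) * ln (pd Phi x c')))))))).
- apply pos_grad_region_open; [apply HC|]. intros c0 Hc0. apply (proj2 HC c0 Hc0).
- intros x [_ [Sx _]]; auto.
- intros x Hx. symmetry. apply (Gmap_exp_form K n1 d pw pu rw ru U); auto.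
- apply C1_mult; [apply C1_mult|].
  + apply C1_const.
  + apply C1_exp, C1_mult; [apply C1_const|auto].
  + apply C1_exp, C1_mult; [apply C1_const|]. apply C1_ln.
    * apply C1_lsum. intros c' Hin. apply In_blk_coords in Hin as [Hin _]; auto.
      apply C1_exp, C1_mult, C1_mult; auto using C1_const.
    * intros x _. destruct (blk_coords_nonempty K n1 d b Hn1 Hd Hb) as [c0 Hc0].
      eapply Rlt_le_trans; [|apply (lsum_ge_term _ _ c0); auto; intros; left; apply exp_pos].
      apply exp_pos.
Qed.

Lemma S_plus_blk_norm K n1 d pw pu rw ru x b : 1 < pw -> 1 < pu -> 0 < rw -> 0 < ru ->
  S_plus K n1 d pw pu rw ru x -> (b <= K)%nat ->
  lpnorm (blk_exp K pw pu b) x (blk_coords K n1 d b) = blk_radius K rw ru b.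
Proof.
intros Hpw Hpu Hrw Hru [Sx [Px [Nu Nw]]] Hb.
destruct (blk_norms K n1 d pw pu x) as [Hrow Hu].
unfold blk_exp, blk_radius. destruct (Nat.ltb b K) eqn:E.
- apply Nat.ltb_lt in E. rewrite <- Hrow; auto.
- apply Nat.ltb_ge in E. assert (b = K) by lia. subst. rewrite <- Hu. auto.
Qed.

Lemma S_plus_blk_psum K n1 d pw pu rw ru x b : 1 < pw -> 1 < pu -> 0 < rw -> 0 < ru ->
  S_plus K n1 d pw pu rw ru x -> (b <= K)%nat ->
  psum (blk_exp K pw pu b) x (blk_coords K n1 d b) = Rpower (blk_radius K rw ru b) (blk_exp K pw pu b).
Proof.
intros. apply lpnorm_eq; [apply blk_exp_gt1|apply blk_radius_pos|apply S_plus_blk_norm]; auto.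
Qed.

Lemma S_plus_of_blk_norms K n1 d pw pu rw ru x : 1 < pw -> 1 < pu -> 0 < rw -> 0 < ru ->
  supp K n1 d x -> (forall c, inR K n1 d c = true -> 0 <= x c) ->
  (forall b, (b <= K)%nat -> lpnorm (blk_exp K pw pu b) x (blk_coords K n1 d b) = blk_radius K rw ru b) ->
  S_plus K n1 d pw pu rw ru x.
Proof.
intros Hpw Hpu Hrw Hru Sx Px Hb.
destruct (blk_norms K n1 d pw pu x) as [Hrow Hu].
split; [auto|split; [auto|split]].
- rewrite Hu. specialize (Hb K (le_n K)). unfold blk_exp, blk_radius in Hb. rewrite Nat.ltb_irrefl in Hb. auto.
- intros i Hi. rewrite Hrow by auto. specialize (Hb i (Nat.lt_le_incl _ _ Hi)). unfold blk_exp, blk_radius in Hb.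
  replace (Nat.ltb i K) with true in Hb by (symmetry; apply Nat.ltb_lt; auto). auto.
Qed.

(** * The metric [mu_gamma] and the contraction estimate *)

Definition geodesic (K n1 d : nat) (x y : Pt) (t : R) : Pt :=
  fun c => if inR K n1 d c then exp ((1 - t) * ln (x c) + t * ln (y c)) else 0.

Lemma geodesic_supp K n1 d x y t : supp K n1 d (geodesic K n1 d x y t).
Proof. intros c Hc. unfold geodesic. rewrite Hc. auto. Qed.

Lemma geodesic_pos K n1 d x y t c : inR K n1 d c = true -> 0 < geodesic K n1 d x y t c.
Proof. intros Hc. unfold geodesic. rewrite Hc. apply exp_pos. Qed.

Lemma geodesic_0 K n1 d x y : supp K n1 d x -> (forall c, inR K n1 d c = true -> 0 < x c) ->
  geodesic K n1 d x y 0 = x.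
Proof.
intros Sx Px. apply functional_extensionality. intros c. unfold geodesic.
destruct (inR K n1 d c) eqn:E.
- replace ((1 - 0) * ln (x c) + 0 * ln (y c)) with (ln (x c)) by ring. apply exp_ln; auto.
- rewrite Sx; auto.
Qed.

Lemma geodesic_1 K n1 d x y : supp K n1 d y -> (forall c, inR K n1 d c = true -> 0 < y c) ->
  geodesic K n1 d x y 1 = y.
Proof.
intros Sy Py. apply functional_extensionality. intros c. unfold geodesic.
destruct (inR K n1 d c) eqn:E.
- replace ((1 - 1) * ln (x c) + 1 * ln (y c)) with (ln (y c)) by ring. apply exp_ln; auto.
- rewrite Sy; auto.
Qed.

Lemma geodesic_deriv K n1 d x y t0 c : inR K n1 d c = true ->
  derivable_pt_lim (fun t => geodesic K n1 d x y t c) t0 (geodesic K n1 d x y t0 c * (ln (y c) - ln (x c))).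
Proof.
intros Hc. unfold geodesic. rewrite Hc.
apply derivable_pt_lim_exp_interp.
Qed.

Lemma psum_geodesic K n1 d p x y t L : 1 < p -> 0 <= t <= 1 ->
  (forall c, In c L -> inR K n1 d c = true /\ 0 < x c /\ 0 < y c) ->
  psum p (geodesic K n1 d x y t) L <= (1 - t) * psum p x L + t * psum p y L.
Proof.
intros Hp Ht HL. unfold psum.
replace ((1 - t) * lsum L (fun c => powp (Rabs (x c)) p) + t * lsum L (fun c => powp (Rabs (y c)) p))
  with (lsum L (fun c => (1 - t) * powp (Rabs (x c)) p + t * powp (Rabs (y c)) p))
  by (rewrite lsum_plus, !lsum_scal; ring).
apply lsum_le. intros c Hin. destruct (HL c Hin) as [Hc [Px Py]].
rewrite !Rabs_right by (try (left; apply geodesic_pos; auto); lra).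
rewrite !powp_pos_eq by (auto; apply geodesic_pos; auto).
unfold geodesic. rewrite Hc. unfold Rpower. rewrite ln_exp.
replace (p * ((1 - t) * ln (x c) + t * ln (y c))) with ((1 - t) * (p * ln (x c)) + t * (p * ln (y c))) by ring.
pose proof (exp_convex (1 - t) (p * ln (x c)) (p * ln (y c))) as E.
replace (1 - (1 - t)) with t in E by ring. apply E. lra.
Qed.

Lemma B_pp_blocks K n1 d pw pu rw ru x : 1 < pw -> 1 < pu -> 0 < rw -> 0 < ru ->
  B_pp K n1 d pw pu rw ru x <->
  (supp K n1 d x /\ (forall c, inR K n1 d c = true -> 0 < x c) /\
   forall b, (b <= K)%nat -> psum (blk_exp K pw pu b) x (blk_coords K n1 d b) <= Rpower (blk_radius K rw ru b) (blk_exp K pw pu b)).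
Proof.
intros Hpw Hpu Hrw Hru. destruct (blk_norms K n1 d pw pu x) as [Hrow Hu].
unfold B_pp. split.
- intros [Sx [Px [Nu Nw]]]. split; [auto|split; [auto|]].
  intros b Hb. unfold blk_exp, blk_radius. destruct (Nat.ltb b K) eqn:E.
  + apply Nat.ltb_lt in E. apply lpnorm_le; auto. rewrite <- (Hrow b E). apply Nw; auto.
  + apply Nat.ltb_ge in E. assert (b = K) by lia. subst. apply lpnorm_le; auto. rewrite <- Hu. auto.
- intros [Sx [Px Hb]]. split; [auto|split; [auto|split]].
  + rewrite Hu. apply lpnorm_le; auto. specialize (Hb K (le_n K)). unfold blk_exp, blk_radius in Hb. rewrite Nat.ltb_irrefl in Hb. auto.
  + intros i Hi. rewrite Hrow by auto. apply lpnorm_le; auto. specialize (Hb i (Nat.lt_le_incl _ _ Hi)).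
    unfold blk_exp, blk_radius in Hb. replace (Nat.ltb i K) with true in Hb by (symmetry; apply Nat.ltb_lt; auto). auto.
Qed.

Lemma geodesic_B_pp K n1 d pw pu rw ru x y t : 1 < pw -> 1 < pu -> 0 < rw -> 0 < ru -> 0 <= t <= 1 ->
  B_pp K n1 d pw pu rw ru x -> B_pp K n1 d pw pu rw ru y -> B_pp K n1 d pw pu rw ru (geodesic K n1 d x y t).
Proof.
intros Hpw Hpu Hrw Hru Ht Bx By.
apply B_pp_blocks in Bx, By; auto. apply B_pp_blocks; auto.
destruct Bx as [Sx [Px Nx]], By as [Sy [Py Ny]].
split; [apply geodesic_supp|split; [intros; apply geodesic_pos; auto|]].
intros b Hb. assert (Hp : 1 < blk_exp K pw pu b) by (apply blk_exp_gt1; auto).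
eapply Rle_trans; [apply psum_geodesic; auto|].
- intros c Hin. apply In_blk_coords in Hin; auto. destruct Hin as [Hc _]. auto.
- specialize (Nx b Hb). specialize (Ny b Hb). nra.
Qed.

Definition lndist (K n1 d : nat) (x y : Pt) (k : nat) : R :=
  if Nat.ltb k K then rmaxn n1 (fun j => Rabs (ln (x (CW k j)) - ln (y (CW k j))))
  else rmaxn n1 (fun a => rmaxn d (fun b => Rabs (ln (x (CU a b)) - ln (y (CU a b))))).

Lemma lndist_nonneg K n1 d x y k : 0 <= lndist K n1 d x y k.
Proof. unfold lndist. destruct (Nat.ltb k K); apply rmaxn_nonneg. Qed.

Lemma lndist_sym K n1 d x y k : lndist K n1 d x y k = lndist K n1 d y x k.
Proof.
unfold lndist. destruct (Nat.ltb k K).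
- apply rmaxn_ext. intros. apply Rabs_minus_sym.
- apply rmaxn_ext. intros. apply rmaxn_ext. intros. apply Rabs_minus_sym.
Qed.

Lemma mu_lndist K n1 d gam x y : mu K n1 d gam x y = rsum (S K) (fun k => gam k * lndist K n1 d x y k).
Proof.
unfold mu. simpl. f_equal.
- apply rsum_ext. intros i Hi. unfold lndist. replace (Nat.ltb i K) with true by (symmetry; apply Nat.ltb_lt; auto). auto.
- unfold lndist. rewrite Nat.ltb_irrefl. auto.
Qed.

Lemma ln_gap_le_lndist K n1 d x y c : inR K n1 d c = true ->
  Rabs (ln (x c) - ln (y c)) <= lndist K n1 d x y (blk K c).
Proof.
intros Hc. unfold lndist. destruct c; simpl in *; rewrite andb_true_iff, !Nat.ltb_lt in Hc.
- replace (Nat.ltb i K) with true by (symmetry; apply Nat.ltb_lt; lia).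
  apply (rmaxn_ge n1 (fun j0 => Rabs (ln (x (CW i j0)) - ln (y (CW i j0)))) j). lia.
- rewrite Nat.ltb_irrefl.
  eapply Rle_trans; [|apply (rmaxn_ge n1 (fun a0 => rmaxn d (fun b0 => Rabs (ln (x (CU a0 b0)) - ln (y (CU a0 b0))))) a); lia].
  apply (rmaxn_ge d (fun b0 => Rabs (ln (x (CU a b0)) - ln (y (CU a b0)))) b). lia.
Qed.

Lemma mu_sym K n1 d gam x y : mu K n1 d gam x y = mu K n1 d gam y x.
Proof. rewrite !mu_lndist. apply rsum_ext. intros. rewrite lndist_sym. auto. Qed.

Lemma mu_nonneg K n1 d gam x y : (forall i, (i <= K)%nat -> 0 < gam i) -> 0 <= mu K n1 d gam x y.
Proof.
intros Hg. rewrite mu_lndist. apply rsum_nonneg. intros. apply Rmult_le_pos; [left; apply Hg; lia|apply lndist_nonneg].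
Qed.

Lemma lndist_triangle K n1 d x y z k : lndist K n1 d x z k <= lndist K n1 d x y k + lndist K n1 d y z k.
Proof.
unfold lndist. destruct (Nat.ltb k K).
- eapply Rle_trans; [|apply rmaxn_add; intros; apply Rabs_pos].
  apply rmaxn_mono. intros. replace (ln (x (CW k i)) - ln (z (CW k i))) with
    ((ln (x (CW k i)) - ln (y (CW k i))) + (ln (y (CW k i)) - ln (z (CW k i)))) by ring. apply Rabs_triang.
- eapply Rle_trans; [|apply rmaxn_add; intros; apply rmaxn_nonneg].
  apply rmaxn_mono. intros a Ha.
  eapply Rle_trans; [|apply rmaxn_add; intros; apply Rabs_pos].
  apply rmaxn_mono. intros b Hb. replace (ln (x (CU a b)) - ln (z (CU a b))) with
    ((ln (x (CU a b)) - ln (y (CU a b))) + (ln (y (CU a b)) - ln (z (CU a b)))) by ring. apply Rabs_triang.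
Qed.

Lemma mu_triangle K n1 d gam x y z : (forall i, (i <= K)%nat -> 0 < gam i) ->
  mu K n1 d gam x z <= mu K n1 d gam x y + mu K n1 d gam y z.
Proof.
intros Hg. rewrite !mu_lndist. rewrite <- rsum_plus. apply rsum_le. intros k Hk.
pose proof (lndist_triangle K n1 d x y z k). assert (0 < gam k) by (apply Hg; lia). nra.
Qed.

Lemma lndist_le_mu K n1 d gam x y b : (forall i, (i <= K)%nat -> 0 < gam i) -> (b <= K)%nat ->
  gam b * lndist K n1 d x y b <= mu K n1 d gam x y.
Proof.
intros Hg Hb. rewrite mu_lndist. apply (rsum_ge_term (S K) (fun k => gam k * lndist K n1 d x y k)); [|lia].
intros. apply Rmult_le_pos; [left; apply Hg; lia|apply lndist_nonneg].
Qed.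

Lemma mu_le0_eq K n1 d gam x y : (forall i, (i <= K)%nat -> 0 < gam i) ->
  (forall c, inR K n1 d c = true -> 0 < x c) -> (forall c, inR K n1 d c = true -> 0 < y c) ->
  mu K n1 d gam x y <= 0 -> forall c, inR K n1 d c = true -> x c = y c.
Proof.
intros Hg Px Py H0 c Hc.
pose proof (lndist_le_mu K n1 d gam x y (blk K c) Hg (blk_le K n1 d c Hc)).
pose proof (lndist_nonneg K n1 d x y (blk K c)).
assert (0 < gam (blk K c)) by (apply Hg; apply blk_le with n1 d; auto).
assert (lndist K n1 d x y (blk K c) = 0) by nra.
pose proof (ln_gap_le_lndist K n1 d x y c Hc). rewrite H3 in H4.
pose proof (Rabs_pos (ln (x c) - ln (y c))).
assert (Rabs (ln (x c) - ln (y c)) = 0) by lra.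
assert (ln (x c) - ln (y c) = 0) by (destruct (Rcase_abs (ln (x c) - ln (y c))); [rewrite Rabs_left in H6|rewrite Rabs_right in H6]; lra).
apply ln_inv; auto; lra.
Qed.

Lemma abs_sub_le_ln_gap a b M : 0 < a <= M -> 0 < b <= M -> Rabs (a - b) <= M * Rabs (ln a - ln b).
Proof.
intros Ha Hb.
assert (key : forall a b, 0 < b <= a -> a <= M -> a - b <= M * (ln a - ln b)).
{ clear. intros a b Hb Ha.
  assert (Hs : ln (b / a) <= b / a - 1).
  { pose proof (exp_ineq1_le (ln (b / a))). rewrite exp_ln in H; [lra|]. apply Rdiv_lt_0_compat; lra. }
  unfold Rdiv in Hs. rewrite ln_mult, ln_Rinv in Hs by (try apply Rinv_0_lt_compat; lra).
  assert (H1 : a * (ln b - ln a) <= a * (b / a - 1)) by (apply Rmult_le_compat_l; lra).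
  replace (a * (b / a - 1)) with (b - a) in H1 by (field; lra).
  assert (0 <= ln a - ln b).
  { destruct (Req_dec a b); [subst; lra|]. left. apply Rlt_0_minus. apply ln_increasing; lra. }
  nra. }
destruct (Rle_dec b a).
- rewrite !Rabs_right; [apply key; lra| |lra].
  destruct (Req_dec a b); [subst; lra|]. left. apply Rlt_0_minus. apply ln_increasing; lra.
- rewrite Rabs_minus_sym, (Rabs_minus_sym (ln a)). rewrite !Rabs_right; [apply key; lra| |lra].
  left. apply Rlt_0_minus. apply ln_increasing; lra.
Qed.

Lemma entry_le_blk_radius K n1 d pw pu rw ru x c : 1 < pw -> 1 < pu -> 0 < rw -> 0 < ru ->
  B_pp K n1 d pw pu rw ru x -> inR K n1 d c = true -> x c <= blk_radius K rw ru (blk K c).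
Proof.
intros Hpw Hpu Hrw Hru Bx Hc.
apply B_pp_blocks in Bx; auto. destruct Bx as [Sx [Px Nx]].
pose proof (blk_le K n1 d c Hc) as Hb.
specialize (Nx _ Hb).
assert (Hp : 1 < blk_exp K pw pu (blk K c)) by (apply blk_exp_gt1; auto).
assert (Hr : 0 < blk_radius K rw ru (blk K c)) by (apply blk_radius_pos; auto).
apply lpnorm_le in Nx; auto.
pose proof (abs_le_lpnorm (blk_exp K pw pu (blk K c)) x _ c Hp (In_blk_coords_self K n1 d c Hc)).
pose proof (Px c Hc). rewrite Rabs_right in H by lra. lra.
Qed.

Lemma linf_le K n1 d x B : 0 <= B -> (forall c, inR K n1 d c = true -> Rabs (x c) <= B) ->
  linf K n1 d x <= B.
Proof.
intros HB H. unfold linf. apply Rmax_lub.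
- apply rmaxn_le; auto. intros i Hi. apply rmaxn_le; auto. intros j Hj.
  apply H. simpl. rewrite andb_true_iff, !Nat.ltb_lt. auto.
- apply rmaxn_le; auto. intros a Ha. apply rmaxn_le; auto. intros b Hb.
  apply H. simpl. rewrite andb_true_iff, !Nat.ltb_lt. auto.
Qed.

Lemma abs_le_linf K n1 d x c : inR K n1 d c = true -> Rabs (x c) <= linf K n1 d x.
Proof.
intros Hc. unfold linf. destruct c; simpl in Hc; rewrite andb_true_iff, !Nat.ltb_lt in Hc.
- eapply Rle_trans; [|apply Rmax_l].
  eapply Rle_trans; [|apply (rmaxn_ge K (fun i0 => rmaxn n1 (fun j0 => Rabs (x (CW i0 j0)))) i); lia].
  apply (rmaxn_ge n1 (fun j0 => Rabs (x (CW i j0))) j). lia.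
- eapply Rle_trans; [|apply Rmax_r].
  eapply Rle_trans; [|apply (rmaxn_ge n1 (fun a0 => rmaxn d (fun b0 => Rabs (x (CU a0 b0)))) a); lia].
  apply (rmaxn_ge d (fun b0 => Rabs (x (CU a b0))) b). lia.
Qed.

Section LinfBound.
Variables (K n1 d : nat) (pw pu rw ru : R) (gam : nat -> R).
Hypotheses (Hpw : 1 < pw) (Hpu : 1 < pu) (Hrw : 0 < rw) (Hru : 0 < ru).
Hypothesis gam_pos : forall i, (i <= K)%nat -> 0 < gam i.

Let m := Rmin (gam K / ru) (rminn K gam / rw).

Lemma linf_scale_pos : 0 < m.
Proof.
assert (0 < gam K) by (apply gam_pos; lia).
assert (0 < rminn K gam) by (apply rminn_pos; intros; apply gam_pos; lia).
apply Rmin_pos; apply Rdiv_lt_0_compat; auto.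
Qed.

Lemma blk_radius_linf_scale_le b : (b <= K)%nat -> blk_radius K rw ru b * m <= gam b.
Proof.
intros Hb. unfold blk_radius, m. destruct (Nat.ltb b K) eqn:E.
- apply Nat.ltb_lt in E.
  assert (Rmin (gam K / ru) (rminn K gam / rw) <= rminn K gam / rw) by apply Rmin_r.
  assert (rminn K gam <= gam b) by (apply rminn_le; auto).
  assert (rw * (rminn K gam / rw) = rminn K gam) by (field; lra).
  nra.
- apply Nat.ltb_ge in E. replace b with K by lia.
  assert (Rmin (gam K / ru) (rminn K gam / rw) <= gam K / ru) by apply Rmin_l.
  assert (ru * (gam K / ru) = gam K) by (field; lra).
  nra.
Qed.

Lemma linf_le_mu x y : B_pp K n1 d pw pu rw ru x -> B_pp K n1 d pw pu rw ru y ->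
  linf K n1 d (fun c => x c - y c) <= mu K n1 d gam x y / m.
Proof.
intros Bx By. pose proof linf_scale_pos as Hm.
assert (Hmu : 0 <= mu K n1 d gam x y) by (apply mu_nonneg; auto).
apply linf_le; [unfold Rdiv; apply Rmult_le_pos; [auto|left; apply Rinv_0_lt_compat; auto]|].
intros c Hc. set (b := blk K c).
assert (Hb : (b <= K)%nat) by (apply blk_le with n1 d; auto).
assert (Hr : 0 < blk_radius K rw ru b) by (apply blk_radius_pos; auto).
assert (0 < x c) by (apply Bx; auto). assert (0 < y c) by (apply By; auto).
apply Rle_trans with (blk_radius K rw ru b * Rabs (ln (x c) - ln (y c))).
{ apply abs_sub_le_ln_gap; split; auto; apply entry_le_blk_radius with n1 d pw pu; auto. }
pose proof (ln_gap_le_lndist K n1 d x y c Hc) as Hgap. fold b in Hgap.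
pose proof (lndist_le_mu K n1 d gam x y b gam_pos Hb).
pose proof (blk_radius_linf_scale_le b Hb).
pose proof (lndist_nonneg K n1 d x y b).
apply (Rmult_le_reg_r m); auto. replace (mu K n1 d gam x y / m * m) with (mu K n1 d gam x y) by (field; lra).
assert (blk_radius K rw ru b * Rabs (ln (x c) - ln (y c)) * m <= blk_radius K rw ru b * lndist K n1 d x y b * m)
  by (apply Rmult_le_compat_r; [lra|apply Rmult_le_compat_l; lra]).
assert (blk_radius K rw ru b * m * lndist K n1 d x y b <= gam b * lndist K n1 d x y b)
  by (apply Rmult_le_compat_r; lra).
lra.
Qed.

End LinfBound.

Lemma rsum_left_eigenvector m (A : nat -> nat -> R) (gam D : nat -> R) lam :
  (forall k, (k < m)%nat -> rsum m (fun i => A i k * gam i) = lam * gam k) ->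
  rsum m (fun i => gam i * rsum m (fun k => A i k * D k)) = lam * rsum m (fun k => gam k * D k).
Proof.
intros Heig.
replace (rsum m (fun i => gam i * rsum m (fun k => A i k * D k)))
  with (rsum m (fun i => rsum m (fun k => (A i k * gam i) * D k))).
2:{ apply rsum_ext. intros. rewrite <- rsum_scal. apply rsum_ext. intros. ring. }
rewrite rsum_swap, <- rsum_scal. apply rsum_ext. intros k Hk.
replace (rsum m (fun i => A i k * gam i * D k)) with (rsum m (fun i => A i k * gam i) * D k).
- rewrite Heig by lia. ring.
- rewrite Rmult_comm, <- rsum_scal. apply rsum_ext. intros. ring.
Qed.

Section Contraction.
Variables (K n1 d : nat) (pw pu rw ru : R) (U : Pt -> Prop) (Phi : Pt -> R) (A : nat -> nat -> R).
Hypotheses (Hn1 : (1 <= n1)%nat) (Hd : (1 <= d)%nat) (Hpw : 1 < pw) (Hpu : 1 < pu)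
  (Hrw : 0 < rw) (Hru : 0 < ru).
Hypothesis Phi_C2 : C2_open K n1 d U Phi.
Hypothesis B_pp_sub : forall x, B_pp K n1 d pw pu rw ru x -> U x.
Hypothesis grad_pos :
  forall x, B_pp K n1 d pw pu rw ru x -> forall c, inR K n1 d c = true -> 0 < pd Phi x c.
Hypothesis A_nonneg : forall i k, (i <= K)%nat -> (k <= K)%nat -> 0 <= A i k.
Hypothesis logderiv_bound : forall x, B_pp K n1 d pw pu rw ru x ->
  forall c, inR K n1 d c = true ->
    (forall k, (k < K)%nat ->
       rsum n1 (fun l => Rabs (pd (fun y => Gmap K n1 d pw pu rw ru Phi y c) x (CW k l)) * x (CW k l))
       <= A (blk K c) k * Gmap K n1 d pw pu rw ru Phi x c) /\
    rsum n1 (fun a => rsum d (fun b =>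
         Rabs (pd (fun y => Gmap K n1 d pw pu rw ru Phi y c) x (CU a b)) * x (CU a b)))
       <= A (blk K c) K * Gmap K n1 d pw pu rw ru Phi x c.

Local Notation G := (Gmap K n1 d pw pu rw ru Phi).
Local Notation Bpp := (B_pp K n1 d pw pu rw ru).

Lemma B_pp_pos_grad_region x : Bpp x -> pos_grad_region K n1 d U Phi x.
Proof. intros Bx. split; [auto|split; [apply Bx|apply grad_pos; auto]]. Qed.

Lemma logderiv_weighted_bound w c (delta : Co -> R) (D : nat -> R) :
  Bpp w -> inR K n1 d c = true -> (forall k, 0 <= D k) ->
  (forall c', inR K n1 d c' = true -> Rabs (delta c') <= D (blk K c')) ->
  allsum K n1 d (fun c' => Rabs (pd (fun y => G y c) w c' * (w c' * delta c')))
    <= G w c * rsum (S K) (fun k => A (blk K c) k * D k).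
Proof.
intros Bw Hc HD Hdelta.
set (F := fun y => G y c).
destruct (logderiv_bound w Bw c Hc) as [HAw HAu].
assert (Hterm : forall c', inR K n1 d c' = true ->
   Rabs (pd F w c' * (w c' * delta c')) <= D (blk K c') * (Rabs (pd F w c') * w c')).
{ intros c' Hc'. rewrite !Rabs_mult.
  assert (0 < w c') by (apply Bw; auto). rewrite (Rabs_right (w c')) by lra.
  specialize (Hdelta c' Hc'). pose proof (Rabs_pos (pd F w c')).
  assert (Rabs (pd F w c') * w c' * Rabs (delta c') <= Rabs (pd F w c') * w c' * D (blk K c'))
    by (apply Rmult_le_compat_l; [apply Rmult_le_pos|]; lra).
  lra. }
unfold allsum.
replace (G w c * rsum (S K) (fun k => A (blk K c) k * D k))
  with (rsum K (fun k => D k * (A (blk K c) k * G w c)) + D K * (A (blk K c) K * G w c)).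
2:{ simpl. rewrite Rmult_plus_distr_l, <- rsum_scal. f_equal; [apply rsum_ext; intros; ring|ring]. }
apply Rplus_le_compat.
- apply rsum_le. intros k Hk. eapply Rle_trans.
  + apply (rsum_le n1 _ (fun l => D k * (Rabs (pd F w (CW k l)) * w (CW k l)))).
    intros l Hl. apply (Hterm (CW k l)). simpl. rewrite andb_true_iff, !Nat.ltb_lt. auto.
  + rewrite rsum_scal. apply Rmult_le_compat_l; auto.
- eapply Rle_trans.
  + apply (rsum_le n1 _ (fun a => D K * rsum d (fun b => Rabs (pd F w (CU a b)) * w (CU a b)))).
    intros a Ha. rewrite <- rsum_scal. apply rsum_le. intros b Hb.
    apply (Hterm (CU a b)). simpl. rewrite andb_true_iff, !Nat.ltb_lt. auto.
  + rewrite rsum_scal. apply Rmult_le_compat_l; auto.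
Qed.

Lemma ln_Gmap_geodesic_deriv x y c t : Bpp x -> Bpp y -> inR K n1 d c = true -> 0 <= t <= 1 ->
  let z := geodesic K n1 d x y in
  derivable_pt_lim (fun t => ln (G (z t) c)) t
    (/ G (z t) c * allsum K n1 d (fun c' => pd (fun w => G w c) (z t) c' * (z t c' * (ln (y c') - ln (x c'))))).
Proof.
intros Bx By Hc Ht z.
assert (Bz : Bpp (z t)) by (apply geodesic_B_pp; auto).
destruct (Gmap_C1 K n1 d pw pu rw ru U Phi c Hn1 Hd Phi_C2 Hc) as [_ HF].
assert (H1 : derivable_pt_lim (fun t => G (z t) c) t
  (allsum K n1 d (fun c' => pd (fun w => G w c) (z t) c' * (z t c' * (ln (y c') - ln (x c')))))).
{ apply (chain_rule K n1 d (pos_grad_region K n1 d U Phi) (fun w => G w c)).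
  - apply pos_grad_region_open; [apply Phi_C2|intros c0 Hc0; apply (proj2 Phi_C2 c0 Hc0)].
  - intros c' Hc' w Ow. apply (HF c' Hc'). auto.
  - intros c' Hc'. apply (HF c' Hc').
  - intros. apply geodesic_supp.
  - intros c' Hc'. apply geodesic_deriv; auto.
  - apply B_pp_pos_grad_region; auto. }
apply (derivable_pt_lim_comp (fun t => G (z t) c) ln t _ _ H1).
apply derivable_pt_lim_ln, Gmap_pos; auto.
Qed.

Lemma ln_Gmap_gap_le x y c : Bpp x -> Bpp y -> inR K n1 d c = true ->
  Rabs (ln (G x c) - ln (G y c)) <= rsum (S K) (fun k => A (blk K c) k * lndist K n1 d x y k).
Proof.
intros Bx By Hc.
set (z := geodesic K n1 d x y).
destruct (MVT_cor2 (fun t => ln (G (z t) c))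
  (fun t => / G (z t) c * allsum K n1 d (fun c' => pd (fun w => G w c) (z t) c' * (z t c' * (ln (y c') - ln (x c')))))
  0 1 Rlt_0_1) as [th [Hth Hthr]].
{ intros t Ht. apply ln_Gmap_geodesic_deriv; auto; lra. }
assert (E0 : z 0 = x) by (apply geodesic_0; apply Bx).
assert (E1 : z 1 = y) by (apply geodesic_1; apply By).
rewrite E0, E1 in Hth.
rewrite Rabs_minus_sym, Hth. replace (1 - 0) with 1 by ring. rewrite Rmult_1_r.
assert (Bw : Bpp (z th)) by (apply geodesic_B_pp; auto; lra).
assert (Fw : 0 < G (z th) c) by (apply Gmap_pos; auto).
rewrite Rabs_mult, Rabs_inv, Rabs_right by lra.
apply (Rmult_le_reg_l (G (z th) c)); auto. rewrite <- Rmult_assoc, Rinv_r, Rmult_1_l by lra.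
eapply Rle_trans; [apply allsum_abs|].
apply logderiv_weighted_bound; auto using lndist_nonneg.
intros c' Hc'. rewrite Rabs_minus_sym. apply ln_gap_le_lndist; auto.
Qed.

Lemma lndist_Gmap_le x y i : Bpp x -> Bpp y -> (i <= K)%nat ->
  lndist K n1 d (G x) (G y) i <= rsum (S K) (fun k => A i k * lndist K n1 d x y k).
Proof.
intros Bx By Hi.
assert (Hnn : 0 <= rsum (S K) (fun k => A i k * lndist K n1 d x y k)).
{ apply rsum_nonneg. intros k Hk. apply Rmult_le_pos; [apply A_nonneg; lia|apply lndist_nonneg]. }
unfold lndist at 1. destruct (Nat.ltb i K) eqn:E.
- apply Nat.ltb_lt in E. apply rmaxn_le; auto. intros j Hj.
  apply (ln_Gmap_gap_le x y (CW i j)); auto. simpl. rewrite andb_true_iff, !Nat.ltb_lt; auto.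
- apply Nat.ltb_ge in E. assert (i = K) by lia. subst i.
  apply rmaxn_le; auto. intros a Ha. apply rmaxn_le; auto. intros b Hb.
  apply (ln_Gmap_gap_le x y (CU a b)); auto. simpl. rewrite andb_true_iff, !Nat.ltb_lt; auto.
Qed.

Lemma Gmap_contraction gam lam x y :
  (forall i, (i <= K)%nat -> 0 < gam i) ->
  (forall k, (k <= K)%nat -> rsum (S K) (fun i => A i k * gam i) = lam * gam k) ->
  Bpp x -> Bpp y -> mu K n1 d gam (G x) (G y) <= lam * mu K n1 d gam x y.
Proof.
intros Hg Heig Bx By.
rewrite !mu_lndist, <- (rsum_left_eigenvector (S K) A gam (lndist K n1 d x y) lam)
  by (intros k Hk; apply Heig; lia).
apply rsum_le. intros i Hi. apply Rmult_le_compat_l; [left; apply Hg; lia|].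
apply lndist_Gmap_le; auto. lia.
Qed.

End Contraction.

(** * Critical points, fixed points and maximizers *)

Lemma crit_pt_blk K n1 d pw pu (Phi : Pt -> R) (x : Pt) (lam : nat -> R) :
  (forall i j, (i < K)%nat -> (j < n1)%nat -> pd Phi x (CW i j) = lam i * psi pw (x (CW i j))) ->
  (forall a b, (a < n1)%nat -> (b < d)%nat -> pd Phi x (CU a b) = lam K * psi pu (x (CU a b))) ->
  forall c, inR K n1 d c = true -> pd Phi x c = lam (blk K c) * psi (blk_exp K pw pu (blk K c)) (x c).
Proof.
intros Hw Hu c Hc. destruct c; simpl in *; rewrite andb_true_iff, !Nat.ltb_lt in Hc; unfold blk_exp.
- replace (Nat.ltb i K) with true by (symmetry; apply Nat.ltb_lt; lia). apply Hw; lia.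
- rewrite Nat.ltb_irrefl. apply Hu; lia.
Qed.

Lemma Gmap_fixed_of_crit_pt K n1 d pw pu rw ru Phi x :
  (1 <= n1)%nat -> (1 <= d)%nat -> 1 < pw -> 1 < pu -> 0 < rw -> 0 < ru ->
  crit_pt K n1 d pw pu rw ru Phi x -> (forall c, inR K n1 d c = true -> 0 < pd Phi x c) ->
  Gmap K n1 d pw pu rw ru Phi x = x.
Proof.
intros Hn1 Hd Hpw Hpu Hrw Hru [[Splx Px] [lam [Hw Hu]]] Hg.
pose proof (crit_pt_blk K n1 d pw pu Phi x lam Hw Hu) as Hcb.
apply functional_extensionality. intros c.
destruct (inR K n1 d c) eqn:Hc.
2:{ unfold Gmap. rewrite Hc. symmetry. apply (proj1 Splx). auto. }
set (b := blk K c).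
assert (Hb : (b <= K)%nat) by (apply blk_le with n1 d; auto).
set (p := blk_exp K pw pu b). set (q := conjexp p).
assert (Hp : 1 < p) by (apply blk_exp_gt1; auto).
assert (Hlam : 0 < lam b).
{ specialize (Hcb c Hc). fold b p in Hcb. specialize (Hg c Hc). rewrite Hcb in Hg.
  rewrite psi_pos in Hg by auto. pose proof (Rpower_pos (x c) (p - 1)).
  destruct (Rlt_le_dec 0 (lam b)); auto. nra. }
set (L := Rpower (lam b) (q - 1)).
assert (HL : 0 < L) by apply Rpower_pos.
assert (Hpsi : forall c', inR K n1 d c' = true -> blk K c' = b ->
   psi q (grad K n1 d Phi x c') = L * x c').
{ intros c' Hc' Hb'. unfold grad. rewrite Hc'. rewrite Hcb by auto. rewrite Hb'. fold p.
  rewrite (psi_pos p) by auto. rewrite psi_pos by (apply Rmult_lt_0_compat; auto; apply Rpower_pos).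
  rewrite <- Rpower_mult_distr by (auto; apply Rpower_pos). rewrite Rpower_mult.
  unfold q. rewrite conjexp_mul by auto. rewrite Rpower_1; auto. }
rewrite Gmap_blk_formula by auto. fold b p q.
rewrite (lpnorm_ext _ _ (fun c' => L * x c')).
2:{ intros c' Hin. apply In_blk_coords in Hin; auto. destruct Hin. apply Hpsi; auto. }
rewrite lpnorm_scale by auto.
pose proof (S_plus_blk_norm K n1 d pw pu rw ru x b Hpw Hpu Hrw Hru Splx Hb) as E. fold p in E. rewrite E. rewrite Hpsi by auto.
pose proof (blk_radius_pos K rw ru b Hrw Hru). field. split; lra.
Qed.

Lemma crit_pt_of_Gmap_fixed K n1 d pw pu rw ru Phi x :
  (1 <= n1)%nat -> (1 <= d)%nat -> 1 < pw -> 1 < pu -> 0 < rw -> 0 < ru ->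
  S_pp K n1 d pw pu rw ru x -> (forall c, inR K n1 d c = true -> 0 < pd Phi x c) ->
  Gmap K n1 d pw pu rw ru Phi x = x -> crit_pt K n1 d pw pu rw ru Phi x.
Proof.
intros Hn1 Hd Hpw Hpu Hrw Hru Sx Hg Hfix.
set (N := fun b => lpnorm (blk_exp K pw pu b) (fun c' => psi (conjexp (blk_exp K pw pu b)) (grad K n1 d Phi x c')) (blk_coords K n1 d b)).
set (lam := fun b => Rpower (N b / blk_radius K rw ru b) (blk_exp K pw pu b - 1)).
assert (Hgen : forall c, inR K n1 d c = true -> pd Phi x c = lam (blk K c) * psi (blk_exp K pw pu (blk K c)) (x c)).
{ intros c Hc. set (b := blk K c).
  assert (Hb : (b <= K)%nat) by (apply blk_le with n1 d; auto).
  set (p := blk_exp K pw pu b). set (q := conjexp p). set (rho := blk_radius K rw ru b).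
  assert (Hp : 1 < p) by (apply blk_exp_gt1; auto).
  assert (Hr : 0 < rho) by (apply blk_radius_pos; auto).
  assert (HN : 0 < N b).
  { unfold N. apply (lpnorm_pos _ _ _ c); [apply In_blk_coords_self; auto|].
    unfold grad. rewrite Hc, psi_pos by auto. apply Rpower_pos. }
  assert (Hxc : x c = rho / N b * Rpower (pd Phi x c) (q - 1)).
  { assert (E : x c = Gmap K n1 d pw pu rw ru Phi x c) by (rewrite Hfix; auto). rewrite E. rewrite Gmap_blk_formula by auto. fold b p q. unfold grad at 1. rewrite Hc.
    rewrite psi_pos by auto. unfold N, rho. fold p q. unfold Rdiv. ring. }
  assert (Hx : 0 < x c) by (apply Sx; auto).
  rewrite (psi_pos p) by auto. rewrite Hxc.
  rewrite <- Rpower_mult_distr by (try apply Rpower_pos; apply Rdiv_lt_0_compat; auto).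
  rewrite Rpower_mult. rewrite (Rmult_comm (q - 1)). unfold q. rewrite conjexp_mul by auto.
  rewrite Rpower_1 by auto. unfold lam. fold p rho.
  rewrite <- Rmult_assoc, Rpower_mult_distr by (apply Rdiv_lt_0_compat; auto).
  replace (N b / rho * (rho / N b)) with 1 by (field; lra). rewrite Rpower_base_1. ring. }
split; auto. exists lam. split.
- intros i j Hi Hj. assert (Hc : inR K n1 d (CW i j) = true) by (simpl; rewrite andb_true_iff, !Nat.ltb_lt; auto).
  rewrite Hgen by auto. simpl. unfold blk_exp. replace (Nat.ltb i K) with true by (symmetry; apply Nat.ltb_lt; auto). auto.
- intros a b Ha Hb. assert (Hc : inR K n1 d (CU a b) = true) by (simpl; rewrite andb_true_iff, !Nat.ltb_lt; auto).
  rewrite Hgen by auto. simpl. unfold blk_exp. rewrite Nat.ltb_irrefl. auto.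
Qed.

Lemma Rpower_div a b e : 0 < a -> 0 < b -> Rpower (a / b) e = Rpower a e / Rpower b e.
Proof.
intros. unfold Rdiv. rewrite <- Rpower_mult_distr by (auto; apply Rinv_0_lt_compat; auto).
f_equal. unfold Rpower. rewrite ln_Rinv by auto. rewrite <- exp_Ropp. f_equal. ring.
Qed.

Lemma young_scaled x g rho G p : 0 <= x -> 0 < g -> 0 < rho -> 0 < G -> 1 < p ->
  g * x <= rho * G * (powp (x / rho) p / p + powp (g / G) (conjexp p) / conjexp p) /\
  (powp (x / rho) p <> powp (g / G) (conjexp p) ->
     g * x < rho * G * (powp (x / rho) p / p + powp (g / G) (conjexp p) / conjexp p)).
Proof.
intros Hx Hg Hr HG Hp.
assert (0 <= x / rho) by (apply Rmult_le_pos; [auto|left; apply Rinv_0_lt_compat; auto]).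
assert (0 < g / G) by (apply Rdiv_lt_0_compat; auto).
replace (g * x) with (rho * G * (x / rho * (g / G))) by (field; lra).
assert (0 < rho * G) by nra.
split.
- apply Rmult_le_compat_l; [lra|]. apply young; auto; lra.
- intros Hne. apply Rmult_lt_compat_l; auto. apply young_strict; auto.
Qed.

(* Hoelder's inequality [sum g x <= rho ||g||_q] on the sphere [||x||_p = rho], with equality
   only at the point [z] built from [g^(q-1)]. *)
Section Hoelder.
Variables (L : list Co) (p rho : R) (g x : Co -> R).
Hypotheses (Hp : 1 < p) (Hrho : 0 < rho) (L_nonempty : exists c0, In c0 L)
  (g_pos : forall c, In c L -> 0 < g c) (x_nonneg : forall c, In c L -> 0 <= x c)
  (x_sphere : psum p x L = Rpower rho p).

Let q := conjexp p.
Let a := fun c => Rpower (g c) (q - 1).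
Let z := fun c => rho * a c / lpnorm p a L.
Let T := lsum L (fun c => Rpower (g c) q).
Let G := Rpower T (1 / q).

Lemma hoelder_T_pos : 0 < T.
Proof.
destruct L_nonempty as [c0 Hc0].
unfold T. eapply Rlt_le_trans; [|apply (lsum_ge_term _ _ c0); auto; intros; left; apply Rpower_pos].
apply Rpower_pos.
Qed.

Lemma hoelder_dual_norm : lpnorm p a L = Rpower T (1 / p).
Proof.
destruct L_nonempty as [c0 Hc0]. destruct (conjexp_facts p Hp) as [Hq [Hs [Hqp _]]].
unfold lpnorm. rewrite powp_pos_eq.
- f_equal. unfold psum. apply lsum_ext. intros c Hc. unfold a.
  rewrite Rabs_right by (left; apply Rpower_pos). rewrite powp_pos_eq by apply Rpower_pos.
  rewrite Rpower_mult. f_equal. unfold q. lra.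
- unfold psum. eapply Rlt_le_trans; [|apply (lsum_ge_term _ _ c0); auto; intros; apply powp_nonneg].
  apply powp_pos. rewrite Rabs_right; unfold a; [apply Rpower_pos|left; apply Rpower_pos].
Qed.

Lemma hoelder_G_pow : Rpower G q = T.
Proof.
destruct (conjexp_facts p Hp) as [Hq _]. pose proof hoelder_T_pos.
unfold G. rewrite Rpower_mult. replace (1 / q * q) with 1 by (unfold q; field; lra). apply Rpower_1; auto.
Qed.

Lemma lsum_mult_dual_pt : lsum L (fun c => g c * z c) = rho * G.
Proof.
destruct (conjexp_facts p Hp) as [Hq [Hs _]]. fold q in Hq, Hs. pose proof hoelder_T_pos as HT.
assert (HTN : T / lpnorm p a L = G).
{ rewrite hoelder_dual_norm. unfold G. apply (Rmult_eq_reg_r (Rpower T (1 / p))); [|apply Rgt_not_eq; apply Rpower_pos].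
  unfold Rdiv. rewrite Rmult_assoc, Rinv_l by (apply Rgt_not_eq; apply Rpower_pos).
  rewrite <- Rpower_plus. replace (1 * / q + 1 * / p) with 1 by lra. rewrite Rpower_1; auto; ring. }
rewrite <- HTN.
rewrite (lsum_ext L _ (fun c => (rho * / lpnorm p a L) * Rpower (g c) q)).
- rewrite lsum_scal. unfold Rdiv. fold T. ring.
- intros c Hc. unfold z, a. unfold Rdiv.
  replace (g c * (rho * Rpower (g c) (q - 1) * / lpnorm p (fun c0 => Rpower (g c0) (q - 1)) L))
    with (rho * / lpnorm p (fun c0 => Rpower (g c0) (q - 1)) L * (g c * Rpower (g c) (q - 1))) by ring.
  f_equal. rewrite <- (Rpower_1 (g c)) at 1 by auto. rewrite <- Rpower_plus. f_equal. ring.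
Qed.

Lemma lsum_young_scaled :
  lsum L (fun c => rho * G * (powp (x c / rho) p / p + powp (g c / G) q / q)) = rho * G.
Proof.
destruct (conjexp_facts p Hp) as [Hq [Hs _]]. fold q in Hq, Hs.
pose proof hoelder_T_pos as HT. pose proof hoelder_G_pow as HGq.
assert (HG : 0 < G) by apply Rpower_pos.
rewrite lsum_scal, lsum_plus. unfold Rdiv.
rewrite (lsum_ext L (fun c => powp (x c * / rho) p * / p) (fun c => (/ p * / Rpower rho p) * powp (Rabs (x c)) p)).
2:{ intros c Hc. rewrite Rabs_right by (apply Rle_ge; auto). rewrite Rmult_comm, (Rmult_comm (x c)).
    rewrite powp_scale by (auto; apply Rinv_0_lt_compat; auto).
    unfold Rpower at 1. rewrite ln_Rinv by auto. unfold Rpower. rewrite <- exp_Ropp.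
    replace (- (p * ln rho)) with (p * - ln rho) by ring. ring. }
rewrite (lsum_ext L (fun c => powp (g c * / G) q * / q) (fun c => (/ q * / T) * Rpower (g c) q)).
2:{ intros c Hc. rewrite powp_pos_eq by (apply Rmult_lt_0_compat; auto; apply Rinv_0_lt_compat; auto).
    rewrite <- Rpower_mult_distr by (auto; apply Rinv_0_lt_compat; auto).
    rewrite <- HGq. unfold Rpower at 2 3. rewrite ln_Rinv by auto. rewrite <- exp_Ropp.
    replace (q * - ln G) with (- (q * ln G)) by ring. rewrite exp_Ropp. field.
    split; [apply Rgt_not_eq; apply exp_pos|lra]. }
rewrite !lsum_scal. fold T. unfold psum in x_sphere. rewrite x_sphere.
replace (/ p * / Rpower rho p * Rpower rho p) with (/ p) by (field; split; [apply Rgt_not_eq, Rpower_pos|lra]).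
replace (/ q * / T * T) with (/ q) by (field; lra). rewrite Hs. ring.
Qed.

Lemma young_equality_dual_pt c : In c L -> powp (x c / rho) p = powp (g c / G) q -> x c = z c.
Proof.
intros Hc Heq. destruct (conjexp_facts p Hp) as [Hq _]. pose proof hoelder_T_pos as HT.
assert (HG : 0 < G) by apply Rpower_pos. pose proof (g_pos c Hc) as Hgc.
assert (Hxp : 0 < x c).
{ destruct (x_nonneg c Hc) as [H|H]; auto. rewrite <- H in Heq. unfold Rdiv in Heq.
  rewrite Rmult_0_l, powp_nonpos in Heq by lra.
  pose proof (powp_pos (g c / G) q ltac:(apply Rdiv_lt_0_compat; auto)). lra. }
assert (Hxr : 0 < x c / rho) by (apply Rdiv_lt_0_compat; auto).
rewrite !powp_pos_eq in Heq by (auto; apply Rdiv_lt_0_compat; auto).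
assert (E1 : x c / rho = Rpower (g c / G) (q - 1)).
{ rewrite <- (Rpower_1 (x c / rho)) by auto. replace 1 with (p * (1 / p)) by (field; lra).
  rewrite <- Rpower_mult, Heq, Rpower_mult. f_equal. unfold q, conjexp. field. lra. }
unfold z. rewrite hoelder_dual_norm.
assert (E2 : Rpower G (q - 1) = Rpower T (1 / p)).
{ unfold G. rewrite Rpower_mult. f_equal. unfold q, conjexp. field. lra. }
rewrite Rpower_div in E1 by (auto; apply Rdiv_lt_0_compat; auto).
rewrite E2 in E1. unfold a.
apply (Rmult_eq_reg_r (/ rho)); [|apply Rgt_not_eq, Rinv_0_lt_compat; auto].
replace (x c * / rho) with (x c / rho) by auto. rewrite E1. field. split; [lra|apply Rgt_not_eq, Rpower_pos].
Qed.

Lemma hoelder_blk :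
  lsum L (fun c => g c * x c) <= lsum L (fun c => g c * z c) /\
  ((exists c, In c L /\ x c <> z c) -> lsum L (fun c => g c * x c) < lsum L (fun c => g c * z c)).
Proof.
pose proof hoelder_T_pos as HT. assert (HG : 0 < G) by apply Rpower_pos.
assert (Hyoung : forall c, In c L -> _) by (intros c Hc; exact (young_scaled (x c) (g c) rho G p (x_nonneg c Hc) (g_pos c Hc) Hrho HG Hp)).
rewrite lsum_mult_dual_pt, <- lsum_young_scaled. split.
- apply lsum_le. intros c Hc. apply Hyoung; auto.
- intros [c [Hc Hne]]. apply lsum_lt.
  + intros c' Hc'. apply Hyoung; auto.
  + exists c. split; auto. apply Hyoung; auto. intro Heq. apply Hne, young_equality_dual_pt; auto.
Qed.

End Hoelder.

Lemma allsum_blocks K n1 d f : allsum K n1 d f = rsum (S K) (fun b => lsum (blk_coords K n1 d b) f).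
Proof.
unfold allsum. simpl. f_equal.
- apply rsum_ext. intros i Hi. unfold blk_coords. replace (Nat.ltb i K) with true by (symmetry; apply Nat.ltb_lt; auto).
  unfold row_coords. rewrite lsum_map_seq. auto.
- unfold blk_coords. rewrite Nat.ltb_irrefl. unfold u_coords. rewrite lsum_flat_map_seq. apply rsum_ext. intros.
  rewrite lsum_map_seq. auto.
Qed.

Lemma supp_Vopen K n1 d : Vopen K n1 d (supp K n1 d).
Proof. intros x _ _. exists 1. split; [lra|]. intros y Sy _. auto. Qed.

Lemma derivative_pos_increase (phi : R -> R) D : derivable_pt_lim phi 0 D -> 0 < D ->
  exists h, 0 < h <= 1 /\ phi 0 < phi h.
Proof.
intros Hphi HD. destruct (Hphi (D / 2)) as [del Hdel]; [lra|].
set (h := Rmin (del / 2) 1).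
assert (Hh0 : 0 < h) by (apply Rmin_pos; [pose proof (cond_pos del); lra|lra]).
assert (Hh1 : h <= 1) by apply Rmin_r.
assert (Hh2 : h <= del / 2) by apply Rmin_l.
assert (Habs : Rabs h < del) by (rewrite Rabs_right by lra; pose proof (cond_pos del); lra).
specialize (Hdel h (Rgt_not_eq _ _ Hh0) Habs). replace (0 + h) with h in Hdel by ring.
apply Rabs_def2 in Hdel as [_ Hdl1].
exists h. split; [lra|].
assert (D / 2 < (phi h - phi 0) / h) by lra.
apply (Rmult_lt_compat_r h) in H; auto. replace ((phi h - phi 0) / h * h) with (phi h - phi 0) in H by (field; lra).
assert (0 < D / 2 * h) by (apply Rmult_lt_0_compat; lra). lra.
Qed.

Lemma blk_gain K n1 d pw pu rw ru Phi xh b :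
  (1 <= n1)%nat -> (1 <= d)%nat -> 1 < pw -> 1 < pu -> 0 < rw -> 0 < ru -> (b <= K)%nat ->
  S_plus K n1 d pw pu rw ru xh -> (forall c, inR K n1 d c = true -> 0 < pd Phi xh c) ->
  let z := Gmap K n1 d pw pu rw ru Phi xh in
  0 <= lsum (blk_coords K n1 d b) (fun c => pd Phi xh c * (z c - xh c)) /\
  ((exists c, In c (blk_coords K n1 d b) /\ z c <> xh c) ->
     0 < lsum (blk_coords K n1 d b) (fun c => pd Phi xh c * (z c - xh c))).
Proof.
intros Hn1 Hd Hpw Hpu Hrw Hru Hb Sxh Gp z.
set (L := blk_coords K n1 d b). set (p := blk_exp K pw pu b). set (rho := blk_radius K rw ru b).
destruct (hoelder_blk L p rho (fun c => pd Phi xh c) xh) as [H1 H2].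
- apply blk_exp_gt1; auto.
- apply blk_radius_pos; auto.
- apply blk_coords_nonempty; auto.
- intros c Hc. apply In_blk_coords in Hc; auto. apply Gp. tauto.
- intros c Hc. apply In_blk_coords in Hc; auto. apply (proj1 (proj2 Sxh)). tauto.
- apply S_plus_blk_psum; auto.
- cbv beta in H1, H2.
  assert (Ez : forall c, In c L -> z c =
    rho * Rpower (pd Phi xh c) (conjexp p - 1) / lpnorm p (fun c0 => Rpower (pd Phi xh c0) (conjexp p - 1)) L).
  { intros c Hc. unfold z. apply Gmap_on_blk; auto. }
  rewrite (lsum_ext _ _ (fun c => pd Phi xh c * z c - pd Phi xh c * xh c)) by (intros; ring).
  rewrite lsum_minus, (lsum_ext _ (fun c => pd Phi xh c * z c)
    (fun c => pd Phi xh c * (rho * Rpower (pd Phi xh c) (conjexp p - 1) /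
       lpnorm p (fun c0 => Rpower (pd Phi xh c0) (conjexp p - 1)) L))) by (intros c Hc; rewrite Ez; auto).
  split; [lra|]. intros [c [Hc Hne]].
  enough (lsum L (fun c0 => pd Phi xh c0 * xh c0) < lsum L (fun c0 => pd Phi xh c0 *
     (rho * Rpower (pd Phi xh c0) (conjexp p - 1) / lpnorm p (fun c1 => Rpower (pd Phi xh c1) (conjexp p - 1)) L)))
    by lra.
  apply H2. exists c. split; auto. rewrite <- Ez; auto.
Qed.

Section Maximizer.
Variables (K n1 d : nat) (pw pu rw ru : R) (Phi : Pt -> R).
Hypotheses (Hn1 : (1 <= n1)%nat) (Hd : (1 <= d)%nat) (Hpw : 1 < pw) (Hpu : 1 < pu)
  (Hrw : 0 < rw) (Hru : 0 < ru).
Hypothesis Phi_C1_V : Phi_C1 K n1 d Phi.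
Hypothesis grad_pos_B :
  forall x, B_pp K n1 d pw pu rw ru x -> forall c, inR K n1 d c = true -> 0 < pd Phi x c.

Local Notation G := (Gmap K n1 d pw pu rw ru Phi).
Local Notation Splus := (S_plus K n1 d pw pu rw ru).
Local Notation Bpp := (B_pp K n1 d pw pu rw ru).

Lemma Phi_chain_rule (z : R -> Pt) (z' : Co -> R) t0 :
  (forall t, supp K n1 d (z t)) ->
  (forall c, inR K n1 d c = true -> derivable_pt_lim (fun t => z t c) t0 (z' c)) ->
  derivable_pt_lim (fun t => Phi (z t)) t0 (allsum K n1 d (fun c => pd Phi (z t0) c * z' c)).
Proof.
intros Hs Hz.
apply (chain_rule K n1 d (supp K n1 d) Phi (supp_Vopen K n1 d)
  (fun c Hc y Sy => proj1 (Phi_C1_V c Hc) y Sy) (fun c Hc => proj2 (Phi_C1_V c Hc))); auto.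
Qed.

Lemma Gmap_ascent xh : Splus xh -> (forall c, inR K n1 d c = true -> 0 < pd Phi xh c) -> G xh <> xh ->
  0 < allsum K n1 d (fun c => pd Phi xh c * (G xh c - xh c)).
Proof.
intros Sxh Gp Hne.
assert (Sz : S_pp K n1 d pw pu rw ru (G xh)) by (apply Gmap_S_pp; auto).
assert (Hex : exists c, inR K n1 d c = true /\ G xh c <> xh c).
{ apply NNPP. intro H. apply Hne. apply functional_extensionality. intro c.
  destruct (inR K n1 d c) eqn:Hc.
  - apply NNPP. intro H'. apply H. exists c. split; auto.
  - rewrite (proj1 (proj1 Sz)), (proj1 Sxh); auto. }
destruct Hex as [c1 [Hc1 Hne1]].
rewrite allsum_blocks, <- (rsum_zero (S K)). apply rsum_lt.
- intros b Hb. apply (blk_gain K n1 d pw pu rw ru Phi xh b); auto. lia.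
- exists (blk K c1). split; [pose proof (blk_le K n1 d c1 Hc1); lia|].
  apply (blk_gain K n1 d pw pu rw ru Phi xh (blk K c1)); auto; [apply blk_le with n1 d; auto|].
  exists c1. split; [apply In_blk_coords_self; auto|auto].
Qed.

Lemma segment_B_pp xh z h : Splus xh -> S_pp K n1 d pw pu rw ru z -> 0 < h <= 1 ->
  Bpp (fun c => xh c + h * (z c - xh c)).
Proof.
intros Sxh Sz Hh.
assert (Hw : forall c, inR K n1 d c = true -> 0 < xh c + h * (z c - xh c)).
{ intros c Hc. pose proof (proj1 (proj2 Sxh) c Hc). pose proof (proj2 Sz c Hc). nra. }
apply B_pp_blocks; auto. split; [|split; [auto|]].
- intros c Hc. rewrite (proj1 Sxh), (proj1 (proj1 Sz)) by auto. ring.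
- intros b Hb.
  set (p := blk_exp K pw pu b). assert (Hp : 1 < p) by (apply blk_exp_gt1; auto).
  eapply Rle_trans.
  + unfold psum. apply (lsum_le _ _ (fun c => (1 - h) * powp (Rabs (xh c)) p + h * powp (Rabs (z c)) p)).
    intros c Hc. apply In_blk_coords in Hc as [Hc _]; auto.
    pose proof (proj1 (proj2 Sxh) c Hc). pose proof (proj2 Sz c Hc). pose proof (Hw c Hc).
    rewrite !Rabs_right by lra.
    replace (xh c + h * (z c - xh c)) with ((1 - h) * xh c + h * z c) by ring.
    apply powp_convex; auto; lra.
  + rewrite lsum_plus, !lsum_scal.
    fold (psum p xh (blk_coords K n1 d b)) (psum p z (blk_coords K n1 d b)).
    pose proof (S_plus_blk_psum K n1 d pw pu rw ru xh b Hpw Hpu Hrw Hru Sxh Hb) as E1.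
    pose proof (S_plus_blk_psum K n1 d pw pu rw ru z b Hpw Hpu Hrw Hru (proj1 Sz) Hb) as E2.
    fold p in E1, E2. rewrite E1, E2. right. ring.
Qed.

Section RadialPush.
Variable w : Pt.
Hypothesis Bw : Bpp w.

Let s b := blk_radius K rw ru b / lpnorm (blk_exp K pw pu b) w (blk_coords K n1 d b).
Let push (tau : R) : Pt :=
  fun c => if inR K n1 d c then (1 + tau * (s (blk K c) - 1)) * w c else 0.

Lemma blk_norm_pos_B_pp b : (b <= K)%nat -> 0 < lpnorm (blk_exp K pw pu b) w (blk_coords K n1 d b).
Proof.
intros Hb. destruct (blk_coords_nonempty K n1 d b Hn1 Hd Hb) as [c0 Hc0].
apply (lpnorm_pos _ _ _ c0); auto. apply In_blk_coords in Hc0 as [Hc0 _]; auto. apply Bw; auto.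
Qed.

Lemma push_factor_ge1 b : (b <= K)%nat -> 1 <= s b.
Proof.
intros Hb. pose proof (blk_norm_pos_B_pp b Hb).
assert (lpnorm (blk_exp K pw pu b) w (blk_coords K n1 d b) <= blk_radius K rw ru b).
{ apply lpnorm_le; [apply blk_exp_gt1|apply blk_radius_pos|]; auto.
  apply B_pp_blocks in Bw; auto. apply Bw; auto. }
unfold s. apply (Rmult_le_reg_r (lpnorm (blk_exp K pw pu b) w (blk_coords K n1 d b))); auto.
unfold Rdiv. rewrite Rmult_assoc, Rinv_l by lra. lra.
Qed.

Lemma push_blk_norm tau b : 0 <= tau -> (b <= K)%nat ->
  lpnorm (blk_exp K pw pu b) (push tau) (blk_coords K n1 d b)
  = (1 + tau * (s b - 1)) * lpnorm (blk_exp K pw pu b) w (blk_coords K n1 d b).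
Proof.
intros Htau Hb. rewrite (lpnorm_ext _ _ (fun c => (1 + tau * (s b - 1)) * w c)).
- apply lpnorm_scale; [apply blk_exp_gt1; auto|]. pose proof (push_factor_ge1 b Hb). nra.
- intros c Hc. apply In_blk_coords in Hc as [Hc Hbc]; auto. unfold push. rewrite Hc, Hbc. auto.
Qed.

Lemma push_B_pp tau : 0 <= tau <= 1 -> Bpp (push tau).
Proof.
intros Htau. apply B_pp_blocks; auto. split; [|split].
- intros c Hc. unfold push. rewrite Hc. auto.
- intros c Hc. unfold push. rewrite Hc. pose proof (push_factor_ge1 (blk K c) (blk_le K n1 d c Hc)).
  pose proof (proj1 (proj2 Bw) c Hc). apply Rmult_lt_0_compat; nra.
- intros b Hb. apply lpnorm_le; [apply blk_exp_gt1|apply blk_radius_pos|]; auto.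
  rewrite push_blk_norm by (auto; lra).
  pose proof (blk_norm_pos_B_pp b Hb). pose proof (push_factor_ge1 b Hb).
  assert (s b * lpnorm (blk_exp K pw pu b) w (blk_coords K n1 d b) = blk_radius K rw ru b)
    by (unfold s; field; lra).
  assert ((1 + tau * (s b - 1)) * lpnorm (blk_exp K pw pu b) w (blk_coords K n1 d b)
          <= s b * lpnorm (blk_exp K pw pu b) w (blk_coords K n1 d b)) by (apply Rmult_le_compat_r; nra).
  lra.
Qed.

Lemma push_1_S_plus : Splus (push 1).
Proof.
apply S_plus_of_blk_norms; auto.
- intros c Hc. unfold push. rewrite Hc. auto.
- intros c Hc. left. apply (push_B_pp 1); auto; lra.
- intros b Hb. rewrite push_blk_norm by (auto; lra). replace (1 + 1 * (s b - 1)) with (s b) by ring.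
  pose proof (blk_norm_pos_B_pp b Hb). unfold s. field. lra.
Qed.

Lemma Phi_le_push : Phi w <= Phi (push 1).
Proof.
assert (Hq0 : push 0 = w).
{ apply functional_extensionality. intros c. unfold push. destruct (inR K n1 d c) eqn:Hc; [ring|].
  symmetry. apply Bw. auto. }
destruct (MVT_cor2 (fun tau => Phi (push tau))
   (fun tau => allsum K n1 d (fun c => pd Phi (push tau) c * ((s (blk K c) - 1) * w c))) 0 1 Rlt_0_1)
  as [th [Hth Hthr]].
{ intros tau Htau. apply Phi_chain_rule.
  - intros t c Hc. unfold push. rewrite Hc. auto.
  - intros c Hc. unfold push. rewrite Hc. apply derivable_pt_lim_affine_mult. }
assert (0 <= allsum K n1 d (fun c => pd Phi (push th) c * ((s (blk K c) - 1) * w c))).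
{ apply allsum_nonneg. intros c Hc. pose proof (grad_pos_B (push th) (push_B_pp th ltac:(lra)) c Hc).
  pose proof (push_factor_ge1 (blk K c) (blk_le K n1 d c Hc)). pose proof (proj1 (proj2 Bw) c Hc).
  apply Rmult_le_pos; [lra|]. apply Rmult_le_pos; lra. }
rewrite Hq0 in Hth. replace (1 - 0) with 1 in Hth by ring. nra.
Qed.

Lemma B_pp_below_S_plus : exists y, Splus y /\ Phi w <= Phi y.
Proof. exists (push 1). split; [apply push_1_S_plus|apply Phi_le_push]. Qed.

End RadialPush.

Lemma maximizer_Gmap_fixed xh : Splus xh -> (forall c, inR K n1 d c = true -> 0 < pd Phi xh c) ->
  (forall y, Splus y -> Phi y <= Phi xh) -> G xh = xh.
Proof.
intros Sxh Gp Hmax. apply NNPP. intro Hne.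
assert (Sz : S_pp K n1 d pw pu rw ru (G xh)) by (apply Gmap_S_pp; auto).
set (v := fun t c => xh c + t * (G xh c - xh c)).
assert (Hv0 : v 0 = xh) by (apply functional_extensionality; intros; unfold v; ring).
assert (Hsv : forall t, supp K n1 d (v t)).
{ intros t c Hc. unfold v. rewrite (proj1 Sxh), (proj1 (proj1 Sz)) by auto. ring. }
assert (Hdv : forall c, inR K n1 d c = true -> derivable_pt_lim (fun t => v t c) 0 (G xh c - xh c))
  by (intros c Hc; unfold v; apply derivable_pt_lim_affine).
pose proof (Phi_chain_rule v (fun c => G xh c - xh c) 0 Hsv Hdv) as Hch. rewrite Hv0 in Hch.
destruct (derivative_pos_increase (fun t => Phi (v t)) _ Hch (Gmap_ascent xh Sxh Gp Hne)) as [h [Hh Hinc]].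
cbv beta in Hinc. rewrite Hv0 in Hinc.
destruct (B_pp_below_S_plus (v h) (segment_B_pp xh (G xh) h Sxh Sz Hh)) as [y [Sy Hy]].
pose proof (Hmax y Sy). lra.
Qed.

End Maximizer.

(** * Sequential compactness of [S_+] *)

Definition strict_incr (phi : nat -> nat) : Prop := forall n, (phi n < phi (S n))%nat.

Lemma strict_incr_ge phi : strict_incr phi -> forall n, (n <= phi n)%nat.
Proof. intros H n. induction n; [lia|]. specialize (H n). lia. Qed.

Lemma strict_incr_mono phi : strict_incr phi -> forall m n, (m <= n)%nat -> (phi m <= phi n)%nat.
Proof.
intros H m n Hmn. induction Hmn; [lia|]. specialize (H m0). lia.
Qed.

Lemma strict_incr_comp phi psi : strict_incr phi -> strict_incr psi -> strict_incr (fun n => phi (psi n)).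
Proof.
intros H1 H2 n. specialize (H2 n).
assert (phi (S (psi n)) <= phi (psi (S n)))%nat by (apply strict_incr_mono; auto).
specialize (H1 (psi n)). lia.
Qed.

Lemma Un_cv_sub u l psi : strict_incr psi -> Un_cv u l -> Un_cv (fun n => u (psi n)) l.
Proof.
intros Hp Hu eps Heps. destruct (Hu eps Heps) as [N HN]. exists N. intros n Hn.
apply HN. pose proof (strict_incr_ge psi Hp n). lia.
Qed.

Lemma bounded_cv_subseq (u : nat -> R) (M : R) : (forall n, 0 <= u n <= M) ->
  exists psi l, strict_incr psi /\ Un_cv (fun n => u (psi n)) l.
Proof.
intros Hb.
destruct (Bolzano_Weierstrass u (fun c => 0 <= c <= M) (compact_P3 0 M) Hb) as [l Hl].
assert (Hch : forall N k, exists p, (N <= p)%nat /\ Rabs (u p - l) < / INR (S k)).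
{ intros N k. assert (Hpos : 0 < / INR (S k)) by (apply Rinv_0_lt_compat, lt_0_INR; lia).
  destruct (Hl (disc l (mkposreal _ Hpos)) N) as [p [Hp Hv]].
  - exists (mkposreal _ Hpos). intros y Hy. auto.
  - exists p. split; auto. }
assert (Hf : forall Nk : nat * nat, exists p, (fst Nk <= p)%nat /\ Rabs (u p - l) < / INR (S (snd Nk)))
  by (intros [N k]; apply Hch).
destruct (choice _ Hf) as [ch Hch'].
set (psi := fix psi (n : nat) : nat := match n with O => ch (0%nat, 0%nat) | S k => ch (S (psi k), S k) end).
exists psi, l. split.
- intros n. simpl. destruct (Hch' (S (psi n), S n)) as [H _]. simpl in H. lia.
- intros eps Heps.
  destruct (INR_unbounded (/ eps)) as [N HN].
  exists N. intros n Hn. unfold Rdist.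
  assert (Hn' : Rabs (u (psi n) - l) < / INR (S n)).
  { destruct n; simpl; [apply (Hch' (0%nat, 0%nat))|apply (Hch' (S (psi n), S n))]. }
  assert (/ INR (S n) <= eps).
  { assert (0 < INR (S n)) by (apply lt_0_INR; lia).
    assert (INR N <= INR (S n)) by (apply le_INR; lia).
    rewrite <- (Rinv_inv eps). apply Rinv_le_contravar; [apply Rinv_0_lt_compat; auto|lra]. }
  lra.
Qed.

Lemma bounded_cv_subseq_list (Y : nat -> Pt) (M : R) (L : list Co) :
  (forall n c, In c L -> 0 <= Y n c <= M) ->
  exists phi (l : Co -> R), strict_incr phi /\ forall c, In c L -> Un_cv (fun n => Y (phi n) c) (l c).
Proof.
induction L as [|c L IH]; intros Hb.
- exists (fun n => n), (fun _ => 0). split; [intros n; lia|]. intros c [].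
- destruct IH as [phi [l [Hphi Hl]]]; [intros; apply Hb; right; auto|].
  destruct (bounded_cv_subseq (fun n => Y (phi n) c) M) as [psi [l0 [Hpsi Hl0]]]; [intros; apply Hb; left; auto|].
  exists (fun n => phi (psi n)), (fun c' => if Co_eqb c c' then l0 else l c'). split; [apply strict_incr_comp; auto|].
  intros c' [Hc'|Hc'].
  + subst. rewrite Co_eqb_refl. auto.
  + destruct (Co_eqb c c') eqn:E.
    * apply Co_eqb_spec in E. subst. auto.
    * apply (Un_cv_sub (fun n => Y (phi n) c')); auto.
Qed.

Lemma eventually_list (L : list Co) (P : Co -> nat -> Prop) :
  (forall c, In c L -> exists N, forall n, (N <= n)%nat -> P c n) ->
  exists N, forall c n, In c L -> (N <= n)%nat -> P c n.
Proof.
induction L as [|c L IH]; intros H.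
- exists 0%nat. intros c n [].
- destruct (H c (or_introl eq_refl)) as [N1 H1].
  destruct IH as [N2 H2]; [intros; apply H; right; auto|].
  exists (Nat.max N1 N2). intros c' n [Hc|Hc] Hn.
  + subst. apply H1. lia.
  + apply H2; auto. lia.
Qed.

Lemma Un_cv_lsum (L : list Co) (F : nat -> Co -> R) (l : Co -> R) :
  (forall c, In c L -> Un_cv (fun n => F n c) (l c)) ->
  Un_cv (fun n => lsum L (F n)) (lsum L l).
Proof.
induction L as [|c L IH]; intros H; simpl.
- intros eps Heps. exists 0%nat. intros. unfold Rdist. replace (0 - 0) with 0 by ring. rewrite Rabs_R0. auto.
- apply CV_plus; [apply H; left; auto|apply IH; intros; apply H; right; auto].
Qed.

Lemma Un_cv_nonneg u l : (forall n, 0 <= u n) -> Un_cv u l -> 0 <= l.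
Proof.
intros H Hu. destruct (Rle_lt_dec 0 l) as [H1|H1]; auto.
destruct (Hu (- l)) as [N HN]; [lra|]. specialize (HN N (le_n N)). unfold Rdist in HN.
specialize (H N). apply Rabs_def2 in HN. lra.
Qed.

Lemma continuity_pt_powp_abs p : 1 <= p -> forall s, continuity_pt (fun y => powp (Rabs y) p) s.
Proof.
intros Hp s. unfold continuity_pt, continue_in, limit1_in, limit_in. simpl. unfold R_dist.
intros eps Heps.
destruct (Req_dec s 0) as [Hs|Hs].
- subst. exists (Rmin 1 eps). split; [apply Rmin_pos; lra|]. intros y [_ Hy].
  rewrite Rabs_R0, (powp_nonpos 0 p) by lra. replace (y - 0) with y in Hy by ring.
  assert (Hy1 : Rabs y < 1) by (pose proof (Rmin_l 1 eps); lra).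
  assert (Hy2 : Rabs y < eps) by (pose proof (Rmin_r 1 eps); lra).
  replace (powp (Rabs y) p - 0) with (powp (Rabs y) p) by ring.
  rewrite Rabs_right by (apply Rle_ge, powp_nonneg).
  destruct (Rabs_pos y) as [Hya|Hya].
  + rewrite powp_pos_eq by auto. unfold Rpower.
    assert (ln (Rabs y) < 0) by (rewrite <- ln_1; apply ln_increasing; lra).
    assert (p * ln (Rabs y) <= 1 * ln (Rabs y)) by nra.
    assert (exp (p * ln (Rabs y)) <= exp (ln (Rabs y))).
    { destruct H0; [left; apply exp_increasing; lra|right; f_equal; lra]. }
    rewrite exp_ln in H1 by auto. lra.
  + rewrite <- Hya, powp_nonpos by lra. auto.
- assert (Hsa : 0 < Rabs s) by (apply Rabs_pos_lt; auto).
  set (f := fun y => exp (p * ln (Rabs y))).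
  assert (Hf : continuity_pt f s).
  { unfold f. apply continuity_pt_comp with (f1 := fun y => p * ln (Rabs y)) (f2 := exp).
    - apply continuity_pt_comp with (f1 := Rabs) (f2 := fun z => p * ln z).
      + apply Rcontinuity_abs.
      + apply continuity_pt_mult; [apply continuity_pt_const; intros a b; auto|].
        apply derivable_continuous_pt. exists (/ Rabs s). apply derivable_pt_lim_ln. auto.
    - apply derivable_continuous_pt. apply derivable_pt_exp. }
  destruct (Hf eps Heps) as [del [Hdel H]].
  exists (Rmin del (Rabs s)). split; [apply Rmin_pos; auto|]. intros y [[_ Hys] Hy].
  assert (Hy1 : Rabs (y - s) < del) by (pose proof (Rmin_l del (Rabs s)); lra).
  assert (Hy2 : Rabs (y - s) < Rabs s) by (pose proof (Rmin_r del (Rabs s)); lra).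
  assert (Hya : 0 < Rabs y).
  { pose proof (Rabs_triang_inv s y). rewrite Rabs_minus_sym in Hy2. lra. }
  rewrite !powp_pos_eq by auto. unfold Rpower.
  apply (H y). split; [split; [exact I|auto]|]. simpl. unfold R_dist. auto.
Qed.

Lemma S_plus_entry_bounds K n1 d pw pu rw ru x c : 1 < pw -> 1 < pu -> 0 < rw -> 0 < ru ->
  S_plus K n1 d pw pu rw ru x -> inR K n1 d c = true -> 0 <= x c <= Rmax rw ru.
Proof.
intros Hpw Hpu Hrw Hru Sx Hc. pose proof Sx as [_ [Px _]].
split; [auto|].
pose proof (S_plus_blk_norm K n1 d pw pu rw ru x (blk K c) Hpw Hpu Hrw Hru Sx (blk_le K n1 d c Hc)) as E.
assert (Hp : 1 < blk_exp K pw pu (blk K c)) by (apply blk_exp_gt1; auto).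
pose proof (abs_le_lpnorm _ x _ c Hp (In_blk_coords_self K n1 d c Hc)). rewrite E in H.
rewrite Rabs_right in H by (apply Rle_ge; auto).
unfold blk_radius in H. destruct (Nat.ltb (blk K c) K); [pose proof (Rmax_l rw ru)|pose proof (Rmax_r rw ru)]; lra.
Qed.

Lemma Phi_seq_continuous K n1 d Phi (Y : nat -> Pt) y : Phi_C1 K n1 d Phi ->
  (forall n, supp K n1 d (Y n)) -> supp K n1 d y ->
  (forall c, inR K n1 d c = true -> Un_cv (fun n => Y n c) (y c)) ->
  Un_cv (fun n => Phi (Y n)) (Phi y).
Proof.
intros HC1 SY Sy Hl eps Heps.
destruct (continuous_of_C1 K n1 d (supp K n1 d) Phi (supp_Vopen K n1 d)
   (fun c Hc y Sy => proj1 (HC1 c Hc) y Sy) (fun c Hc => proj2 (HC1 c Hc)) y Sy Sy eps Heps) as [del [Hdel H]].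
destruct (eventually_list (coords K n1 d) (fun c n => Rabs (Y n c - y c) < del)) as [N HN].
{ intros c Hc. apply In_coords in Hc. destruct (Hl c Hc del Hdel) as [N HN]. exists N. intros. apply HN; auto. }
exists N. intros n Hn. unfold Rdist. apply H; auto.
intros c Hc. apply HN; auto. apply In_coords; auto.
Qed.

Lemma S_plus_pointwise_limit K n1 d pw pu rw ru (Y : nat -> Pt) y :
  1 < pw -> 1 < pu -> 0 < rw -> 0 < ru ->
  (forall n, S_plus K n1 d pw pu rw ru (Y n)) -> supp K n1 d y ->
  (forall c, inR K n1 d c = true -> Un_cv (fun n => Y n c) (y c)) ->
  S_plus K n1 d pw pu rw ru y.
Proof.
intros Hpw Hpu Hrw Hru SY Sy Hl.
apply S_plus_of_blk_norms; auto.
- intros c Hc. apply (Un_cv_nonneg (fun n => Y n c)); auto. intros n. apply (SY n); auto.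
- intros b Hb. set (p := blk_exp K pw pu b).
  assert (Hp : 1 < p) by (apply blk_exp_gt1; auto).
  apply lpnorm_eq; [auto|apply blk_radius_pos; auto|].
  apply (UL_sequence (fun n => psum p (Y n) (blk_coords K n1 d b))).
  + unfold psum. apply (Un_cv_lsum _ (fun n c => powp (Rabs (Y n c)) p)).
    intros c Hc. apply In_blk_coords in Hc as [Hc _]; auto.
    apply (continuity_seq (fun y => powp (Rabs y) p)); [apply continuity_pt_powp_abs; lra|]. auto.
  + intros eps Heps. exists 0%nat. intros n _. unfold Rdist.
    pose proof (S_plus_blk_psum K n1 d pw pu rw ru (Y n) b Hpw Hpu Hrw Hru (SY n) Hb) as E.
    fold p in E. rewrite E, Rminus_diag, Rabs_R0. auto.
Qed.

Lemma S_plus_seq_compact K n1 d pw pu rw ru Phi :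
  1 < pw -> 1 < pu -> 0 < rw -> 0 < ru -> Phi_C1 K n1 d Phi ->
  forall Y : nat -> Pt, (forall n, S_plus K n1 d pw pu rw ru (Y n)) ->
  exists phi y, strict_incr phi /\ S_plus K n1 d pw pu rw ru y /\ Un_cv (fun n => Phi (Y (phi n))) (Phi y).
Proof.
intros Hpw Hpu Hrw Hru HC1 Y SY.
destruct (bounded_cv_subseq_list Y (Rmax rw ru) (coords K n1 d)) as [phi [l [Hphi Hl]]].
{ intros n c Hc. apply In_coords in Hc. apply (S_plus_entry_bounds K n1 d pw pu rw ru); auto. }
set (y := fun c => if inR K n1 d c then l c else 0).
assert (Sy : supp K n1 d y) by (intros c Hc; unfold y; rewrite Hc; auto).
assert (Hl' : forall c, inR K n1 d c = true -> Un_cv (fun n => Y (phi n) c) (y c)).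
{ intros c Hc. unfold y. rewrite Hc. apply Hl, In_coords; auto. }
exists phi, y. split; [auto|split].
- apply (S_plus_pointwise_limit K n1 d pw pu rw ru (fun n => Y (phi n))); auto.
- apply (Phi_seq_continuous K n1 d Phi (fun n => Y (phi n))); auto. intros n. apply SY.
Qed.

Section SequentialCompactness.
Context {T : Type} (P : T -> Prop) (f : T -> R).
Hypothesis P_inhabited : exists x0, P x0.
Hypothesis seq_compact : forall Y : nat -> T, (forall n, P (Y n)) ->
  exists phi y, strict_incr phi /\ P y /\ Un_cv (fun n => f (Y (phi n))) (f y).

Lemma seq_compact_bounded : exists M, forall y, P y -> f y <= M.
Proof.
apply NNPP. intro HU.
assert (HY : forall n : nat, exists y, P y /\ INR n < f y).
{ intros n. apply NNPP. intro H. apply HU. exists (INR n). intros y Py.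
  destruct (Rle_lt_dec (f y) (INR n)); auto. exfalso. apply H. exists y. auto. }
destruct (choice _ HY) as [Y HY'].
destruct (seq_compact Y (fun n => proj1 (HY' n))) as [phi [yh [Hphi [Pyh Hcv]]]].
destruct (Hcv 1 Rlt_0_1) as [N HN].
destruct (INR_unbounded (f yh + 1)) as [N2 HN2].
set (n := Nat.max N N2).
specialize (HN n ltac:(unfold n; lia)). unfold Rdist in HN. apply Rabs_def2 in HN.
destruct (HY' (phi n)) as [_ Hlow].
assert (INR N2 <= INR (phi n)) by (apply le_INR; pose proof (strict_incr_ge phi Hphi n); unfold n in *; lia).
lra.
Qed.

Lemma seq_compact_max : exists x, P x /\ forall y, P y -> f y <= f x.
Proof.
destruct seq_compact_bounded as [M HM]. destruct P_inhabited as [y0 Py0].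
set (E := fun r => exists y, P y /\ r = f y).
destruct (completeness E) as [m [Hm1 Hm2]].
{ exists M. intros r [y [Py Hr]]. subst. auto. }
{ exists (f y0). exists y0. auto. }
assert (HY : forall n : nat, exists y, P y /\ m - / INR (S n) < f y).
{ intros n. apply NNPP. intro H.
  assert (Hpos : 0 < / INR (S n)) by (apply Rinv_0_lt_compat, lt_0_INR; lia).
  assert (m <= m - / INR (S n)).
  { apply Hm2. intros r [y [Py Hr]]. subst. destruct (Rle_lt_dec (f y) (m - / INR (S n))); auto.
    exfalso. apply H. exists y. auto. }
  lra. }
destruct (choice _ HY) as [Y HY'].
destruct (seq_compact Y (fun n => proj1 (HY' n))) as [phi [yh [Hphi [Pyh Hcv]]]].
exists yh. split; auto.
assert (Hge : m <= f yh).
{ destruct (Rle_lt_dec m (f yh)) as [H|H]; auto. exfalso.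
  set (e := (m - f yh) / 2).
  assert (He : 0 < e) by (unfold e; lra).
  destruct (Hcv e He) as [N HN].
  destruct (INR_unbounded (/ e)) as [N2 HN2].
  set (n := Nat.max N N2).
  specialize (HN n ltac:(unfold n; lia)). unfold Rdist in HN. apply Rabs_def2 in HN.
  destruct (HY' (phi n)) as [_ Hlow].
  assert (Hsmall : / INR (S (phi n)) < e).
  { assert (INR N2 <= INR (S (phi n))) by (apply le_INR; pose proof (strict_incr_ge phi Hphi n); unfold n in *; lia).
    rewrite <- (Rinv_inv e). apply Rinv_lt_contravar; [|lra].
    apply Rmult_lt_0_compat; [apply Rinv_0_lt_compat; auto|apply lt_0_INR; lia]. }
  unfold e in *. lra. }
intros y Py. assert (f y <= m) by (apply Hm1; exists y; auto). lra.
Qed.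

End SequentialCompactness.

(** * Existence of a maximizer; left eigenvalues and the spectral radius *)

Lemma length_blk_coords K n1 d b : (length (blk_coords K n1 d b) <= n1 + n1 * d)%nat.
Proof.
unfold blk_coords, row_coords, u_coords. destruct (Nat.ltb b K).
- rewrite length_map, length_seq. lia.
- rewrite (flat_map_constant_length (c := d)), length_seq; [lia|].
  intros a _. rewrite length_map, length_seq. auto.
Qed.

Lemma powp_le_self x p : 0 <= x <= 1 -> 1 <= p -> powp x p <= x.
Proof.
intros Hx Hp. destruct (Req_dec x 0) as [->|Hx0]; [rewrite powp_nonpos; lra|].
rewrite powp_pos_eq by lra. destruct (Req_dec x 1) as [->|Hx1].
- unfold Rpower. rewrite ln_1, Rmult_0_r, exp_0. lra.
- unfold Rpower. rewrite <- (exp_ln x) at 2 by lra.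
  assert (ln x < 0) by (rewrite <- ln_1; apply ln_increasing; lra).
  assert (p * ln x <= ln x) by nra.
  destruct H0 as [H0| ->]; [left; apply exp_increasing; auto|right; auto].
Qed.

Lemma B_pp_inhabited K n1 d pw pu rw ru : 1 < pw -> 1 < pu -> 0 < rw -> 0 < ru ->
  exists e, B_pp K n1 d pw pu rw ru e.
Proof.
intros Hpw Hpu Hrw Hru.
set (T := INR (n1 + n1 * d) + 1).
assert (HT : 1 <= T) by (unfold T; pose proof (pos_INR (n1 + n1 * d)); lra).
set (m := Rmin (Rpower rw pw) (Rpower ru pu)).
assert (Hm : 0 < m) by (apply Rmin_pos; apply Rpower_pos).
set (eps := Rmin 1 (m / T)).
assert (He : 0 < eps) by (apply Rmin_pos; [lra|apply Rdiv_lt_0_compat; lra]).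
assert (He1 : eps <= 1) by apply Rmin_l.
assert (HeT : eps * T <= m).
{ assert (eps <= m / T) by apply Rmin_r. apply (Rmult_le_compat_r T) in H; [|lra].
  replace (m / T * T) with m in H by (field; lra). lra. }
exists (fun c => if inR K n1 d c then eps else 0).
apply B_pp_blocks; auto. split; [|split].
- intros c Hc. rewrite Hc. auto.
- intros c Hc. rewrite Hc. auto.
- intros b Hb. set (L := blk_coords K n1 d b).
  assert (HL : INR (length L) <= INR (n1 + n1 * d)) by (apply le_INR, length_blk_coords).
  apply Rle_trans with (INR (length L) * eps).
  + apply lsum_le_length. intros c Hc. apply In_blk_coords in Hc as [Hc _]; auto. rewrite Hc.
    rewrite Rabs_right by lra. apply powp_le_self; [lra|]. left. apply blk_exp_gt1; auto.
  + assert (m <= Rpower (blk_radius K rw ru b) (blk_exp K pw pu b)).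
    { unfold m, blk_radius, blk_exp. destruct (Nat.ltb b K); [apply Rmin_l|apply Rmin_r]. }
    unfold T in HeT. nra.
Qed.

Lemma B_pp_of_S_pp K n1 d pw pu rw ru x : S_pp K n1 d pw pu rw ru x -> B_pp K n1 d pw pu rw ru x.
Proof.
intros [[Sx [Px [Nu Nw]]] Pp]. split; [auto|split; [auto|split; [lra|]]]. intros. rewrite Nw; auto; lra.
Qed.

Lemma Phi_max_on_S_plus K n1 d pw pu rw ru Phi :
  (1 <= n1)%nat -> (1 <= d)%nat -> 1 < pw -> 1 < pu -> 0 < rw -> 0 < ru -> Phi_C1 K n1 d Phi ->
  (forall x, B_pp K n1 d pw pu rw ru x -> forall c, inR K n1 d c = true -> 0 < pd Phi x c) ->
  exists xh, S_plus K n1 d pw pu rw ru xh /\ forall y, S_plus K n1 d pw pu rw ru y -> Phi y <= Phi xh.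
Proof.
intros Hn1 Hd Hpw Hpu Hrw Hru HC1 Hg.
apply seq_compact_max; [|apply S_plus_seq_compact; auto].
destruct (B_pp_inhabited K n1 d pw pu rw ru Hpw Hpu Hrw Hru) as [e Be].
exists (Gmap K n1 d pw pu rw ru Phi e). apply Gmap_S_pp; auto.
Qed.

Section LeftEigenvalues.
Import all_boot all_algebra Rstruct GRing.Theory.

Lemma rsum_big m (f : nat -> R) : rsum m f = (\sum_(i < m) f i)%R.
Proof.
elim: m => [|m IH] /=; first by rewrite big_ord0.
by rewrite big_ord_recr /= IH.
Qed.

Lemma sum_shift_diag n (a b : 'I_n -> R) k lam :
  (\sum_i a i * (b i - (if i == k then lam else 0)) = \sum_i a i * b i - lam * a k)%R.
Proof.
rewrite (eq_bigr (fun i => a i * b i - (if i == k then lam * a i else 0))%R); last first.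
  move=> i _; case: eqP => [->|_]; [by rewrite mulrBr (mulrC _ lam)|by rewrite !subr0].
rewrite sumrB; congr (_ - _)%R.
by rewrite (bigD1 k) //= eqxx big1 ?addr0 // => i /negPf ->.
Qed.

Lemma left_eigenvalue_right_eigenvector (m : nat) (A : nat -> nat -> R) (lam : R) (g : nat -> R) :
  (exists k, Peano.lt k m /\ g k <> 0) ->
  (forall k, Peano.lt k m -> rsum m (fun i => A i k * g i) = lam * g k) ->
  exists x : nat -> R, (exists k, Peano.lt k m /\ x k <> 0) /\
    forall i, Peano.lt i m -> rsum m (fun j => A i j * x j) = lam * x i.
Proof.
move=> [k0 [/ltP Hk0 Hg0]] Heig.
pose M := (\matrix_(i < m, j < m) (A i j - (if i == j then lam else 0)))%R : 'M[R]_m.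
pose v := (\row_(i < m) g i)%R : 'rV[R]_m.
have vn0 : v != 0%R.
  by apply/eqP => /rowP /(_ (Ordinal Hk0)); rewrite !mxE.
have vM : (v *m M = 0)%R.
  apply/rowP => k; rewrite !mxE.
  rewrite (eq_bigr (fun i : 'I_m => g i * (A i k - (if i == k then lam else 0)))%R);
    last by move=> i _; rewrite !mxE.
  rewrite sum_shift_diag (eq_bigr (fun i : 'I_m => A i k * g i)%R); last by move=> i _; rewrite mulrC.
  by rewrite -(rsum_big m (fun i => A i k * g i)) Heig ?subrr //; apply/ltP.
have : (\det M == 0)%R by apply/det0P; exists v.
rewrite -det_tr => /det0P [w wn0 wM].
pose x := fun j : nat => if insub j is Some j' then w ord0 j' else 0%R.
have xE (j : 'I_m) : x j = w ord0 j by rewrite /x valK.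
exists x; split.
  have [j Hj] : exists j, w ord0 j != 0%R.
    apply/existsP; move: wn0; apply: contraR; rewrite negb_exists => /forallP H.
    by apply/eqP/rowP => j; rewrite mxE; move: (H j); rewrite negbK => /eqP.
  by exists j; split; [exact/ltP/ltn_ord|rewrite xE; apply/eqP].
move=> i /ltP Hi. set io := Ordinal Hi.
move/rowP: wM => /(_ io); rewrite !mxE => H.
rewrite (eq_bigr (fun j => w ord0 j * (A i j - (if j == io then lam else 0)))%R) in H;
  last by move=> j _; rewrite !mxE eq_sym.
rewrite sum_shift_diag in H.
rewrite rsum_big (eq_bigr (fun j : 'I_m => w ord0 j * A i j)%R); last by move=> j _; rewrite xE mulrC.
have -> : x i = w ord0 io by rewrite -(xE io).
by apply/eqP; rewrite -subr_eq0; apply/eqP.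
Qed.

End LeftEigenvalues.

Lemma left_eigenvalue_le_spectral_radius m (A : nat -> nat -> R) (gam : nat -> R) lam r :
  (1 <= m)%nat -> (forall i k, (i < m)%nat -> (k < m)%nat -> 0 <= A i k) ->
  (forall i, (i < m)%nat -> 0 < gam i) ->
  (forall k, (k < m)%nat -> rsum m (fun i => A i k * gam i) = lam * gam k) ->
  is_spectral_radius m A r -> 0 <= lam <= r.
Proof.
intros Hm HA Hg Heig Hr. split.
- specialize (Heig 0%nat ltac:(lia)).
  assert (0 <= rsum m (fun i => A i 0%nat * gam i)).
  { apply rsum_nonneg. intros i Hi. apply Rmult_le_pos; [apply HA; lia|left; apply Hg; lia]. }
  assert (0 < gam 0%nat) by (apply Hg; lia). nra.
- destruct (left_eigenvalue_right_eigenvector m A lam gam) as [xv [[k [Hk Hxk]] Hxv]].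
  + exists 0%nat. split; [lia|]. apply Rgt_not_eq, Hg. lia.
  + exact Heig.
  + destruct Hr as [_ Hr]. specialize (Hr lam 0).
    assert (Hce : is_ceigenvalue m A lam 0).
    { exists xv, (fun _ => 0). split; [exists k; auto|].
      intros i Hi. split.
      - rewrite Hxv by auto. ring.
      - rewrite (rsum_ext _ _ (fun _ => 0)) by (intros; ring). rewrite rsum_zero. ring. }
    specialize (Hr Hce). replace (lam * lam + 0 * 0) with (Rsqr lam) in Hr by (unfold Rsqr; ring).
    rewrite sqrt_Rsqr_abs in Hr. pose proof (Rle_abs lam). lra.
Qed.

(** * Iterating a contraction *)

Section ContractionIterates.
Variables (K n1 d : nat) (pw pu rw ru : R) (gam : nat -> R) (G : Pt -> Pt) (lam r : R) (xs : Pt).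
Hypotheses (Hpw : 1 < pw) (Hpu : 1 < pu) (Hrw : 0 < rw) (Hru : 0 < ru).
Hypothesis gam_pos : forall i, (i <= K)%nat -> 0 < gam i.
Hypotheses (lam_range : 0 <= lam <= r) (r_lt_1 : r < 1).
Hypothesis G_S_pp : forall x, S_pp K n1 d pw pu rw ru x -> S_pp K n1 d pw pu rw ru (G x).
Hypothesis G_contraction : forall x y, B_pp K n1 d pw pu rw ru x -> B_pp K n1 d pw pu rw ru y ->
  mu K n1 d gam (G x) (G y) <= lam * mu K n1 d gam x y.
Hypotheses (xs_S_pp : S_pp K n1 d pw pu rw ru xs) (xs_fixed : G xs = xs).

Local Notation Spp := (S_pp K n1 d pw pu rw ru).
Local Notation mu := (mu K n1 d gam).
Let m := Rmin (gam K / ru) (rminn K gam / rw).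

Lemma mu_to_fixed_point_le x : Spp x -> mu (G x) (G xs) <= lam * mu x xs.
Proof. intros Sx. apply G_contraction; apply B_pp_of_S_pp; auto. Qed.

Lemma fixed_point_unique y : Spp y -> G y = y -> forall c, y c = xs c.
Proof.
intros Sy Fy c.
assert (Hm : mu y xs <= 0).
{ pose proof (mu_to_fixed_point_le y Sy) as H. rewrite Fy, xs_fixed in H.
  pose proof (mu_nonneg K n1 d gam y xs gam_pos). nra. }
destruct (inR K n1 d c) eqn:Hc.
- apply (mu_le0_eq K n1 d gam y xs gam_pos); auto; [apply Sy|apply xs_S_pp].
- rewrite (proj1 (proj1 Sy)), (proj1 (proj1 xs_S_pp)); auto.
Qed.

Lemma iterate_S_pp x0 : Spp x0 -> forall k, Spp (Nat.iter k G x0).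
Proof. intros S0 k. induction k; simpl; auto. Qed.

Lemma iterate_mu_le x0 : Spp x0 -> forall k, mu (Nat.iter k G x0) xs <= lam ^ k * mu x0 xs.
Proof.
intros S0 k. induction k; simpl; [lra|].
pose proof (mu_to_fixed_point_le _ (iterate_S_pp x0 S0 k)) as H. rewrite xs_fixed in H.
assert (lam * mu (Nat.iter k G x0) xs <= lam * (lam ^ k * mu x0 xs)) by (apply Rmult_le_compat_l; lra).
lra.
Qed.

Lemma mu_start_le x0 : Spp x0 -> mu x0 xs <= mu (G x0) x0 / (1 - lam).
Proof.
intros S0.
pose proof (mu_triangle K n1 d gam x0 (G x0) xs gam_pos) as T1.
pose proof (mu_to_fixed_point_le x0 S0) as T2. rewrite xs_fixed in T2.
rewrite (mu_sym K n1 d gam x0 (G x0)) in T1.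
apply (Rmult_le_reg_r (1 - lam)); [lra|].
replace (mu (G x0) x0 / (1 - lam) * (1 - lam)) with (mu (G x0) x0) by (field; lra). nra.
Qed.

Lemma iterate_linf_le x0 : Spp x0 -> forall k,
  linf K n1 d (fun c => Nat.iter k G x0 c - xs c) <= r ^ k * mu (G x0) x0 / ((1 - r) * m).
Proof.
intros S0 k.
assert (Hm : 0 < m) by (apply linf_scale_pos; auto).
set (C := mu (G x0) x0).
assert (HC : 0 <= C) by (apply mu_nonneg; auto).
assert (H1 : mu (Nat.iter k G x0) xs <= r ^ k * (C / (1 - r))).
{ eapply Rle_trans; [apply iterate_mu_le; auto|].
  assert (lam ^ k <= r ^ k) by (apply pow_incr; lra).
  assert (0 <= lam ^ k) by (apply pow_le; lra).
  assert (C / (1 - lam) <= C / (1 - r)) by (apply Rmult_le_compat_l; [auto|apply Rinv_le_contravar; lra]).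
  assert (0 <= C / (1 - lam)) by (apply Rmult_le_pos; [auto|left; apply Rinv_0_lt_compat; lra]).
  apply Rle_trans with (lam ^ k * (C / (1 - lam))); [apply Rmult_le_compat_l, mu_start_le; auto|].
  apply Rmult_le_compat; auto. }
eapply Rle_trans; [apply (linf_le_mu K n1 d pw pu rw ru gam); auto; apply B_pp_of_S_pp; auto;
  apply iterate_S_pp; auto|].
fold m. replace (r ^ k * C / ((1 - r) * m)) with (r ^ k * (C / (1 - r)) / m) by (field; lra).
apply Rmult_le_compat_r; [left; apply Rinv_0_lt_compat; auto|auto].
Qed.

Lemma iterate_cv x0 : Spp x0 -> forall eps, 0 < eps -> exists N, forall k, (N <= k)%nat ->
  forall c, inR K n1 d c = true -> Rabs (Nat.iter k G x0 c - xs c) < eps.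
Proof.
intros S0 eps Heps.
assert (Hm : 0 < m) by (apply linf_scale_pos; auto).
set (B := mu (G x0) x0 / ((1 - r) * m)).
assert (HB : 0 <= B).
{ unfold B, Rdiv. apply Rmult_le_pos; [apply mu_nonneg; auto|].
  left. apply Rinv_0_lt_compat. apply Rmult_lt_0_compat; lra. }
destruct (pow_lt_1_zero r ltac:(rewrite Rabs_right; lra) (eps / (B + 1))) as [N HN].
{ apply Rdiv_lt_0_compat; lra. }
exists N. intros k Hk c Hc.
specialize (HN k Hk). rewrite Rabs_right in HN by (apply Rle_ge, pow_le; lra).
eapply Rle_lt_trans; [apply (abs_le_linf K n1 d (fun c => Nat.iter k G x0 c - xs c) c Hc)|].
eapply Rle_lt_trans; [apply iterate_linf_le; auto|].
replace (r ^ k * mu (G x0) x0 / ((1 - r) * m)) with (r ^ k * B) by (unfold B, Rdiv; ring).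
assert (r ^ k * B <= eps / (B + 1) * B) by (apply Rmult_le_compat_r; lra).
assert (eps / (B + 1) * B < eps).
{ apply (Rmult_lt_reg_r (B + 1)); [lra|].
  replace (eps / (B + 1) * B * (B + 1)) with (eps * B) by (field; lra). nra. }
lra.
Qed.

End ContractionIterates.

Theorem mainTheorem7
  (K n1 d : nat) (pw pu rw ru : R) (Phi : Pt -> R)
  (A : nat -> nat -> R) (gam : nat -> R) (r : R)
  (HK : (1 <= K)%nat) (Hn1 : (1 <= n1)%nat) (Hd : (1 <= d)%nat)
  (Hpw : 1 < pw) (Hpu : 1 < pu) (Hrw : 0 < rw) (Hru : 0 < ru)
  (HC1 : Phi_C1 K n1 d Phi)
  (HC2 : exists U : Pt -> Prop, Vopen K n1 d U /\
           (forall x, B_pp K n1 d pw pu rw ru x -> U x) /\ C2_on K n1 d U Phi)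
  (Hgradpos : forall x, (S_plus K n1 d pw pu rw ru x \/ B_pp K n1 d pw pu rw ru x) ->
       forall c, inR K n1 d c = true -> 0 < pd Phi x c)
  (HAnn : forall i k, (i <= K)%nat -> (k <= K)%nat -> 0 <= A i k)
  (HA : forall x, B_pp K n1 d pw pu rw ru x ->
       forall c, inR K n1 d c = true ->
         (forall k, (k < K)%nat ->
            rsum n1 (fun l => Rabs (pd (fun y => Gmap K n1 d pw pu rw ru Phi y c) x (CW k l))
                              * x (CW k l))
            <= A (blk K c) k * Gmap K n1 d pw pu rw ru Phi x c) /\
         rsum n1 (fun a => rsum d (fun b =>
              Rabs (pd (fun y => Gmap K n1 d pw pu rw ru Phi y c) x (CU a b)) * x (CU a b)))
            <= A (blk K c) K * Gmap K n1 d pw pu rw ru Phi x c)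
  (Hgam_pos : forall i, (i <= K)%nat -> 0 < gam i)
  (Hgam_eig : exists lam, forall k, (k <= K)%nat ->
       rsum (S K) (fun i => A i k * gam i) = lam * gam k)
  (Hr : is_spectral_radius (S K) A r)
  (Hr1 : r < 1) :
  exists xs : Pt,
    crit_pt K n1 d pw pu rw ru Phi xs /\
    (forall y, crit_pt K n1 d pw pu rw ru Phi y -> forall c, y c = xs c) /\
    (forall y, S_plus K n1 d pw pu rw ru y -> Phi y <= Phi xs) /\
    (forall x0, S_pp K n1 d pw pu rw ru x0 ->
       (forall eps, 0 < eps -> exists N, forall k, (N <= k)%nat ->
          forall c, inR K n1 d c = true ->
            Rabs (Nat.iter k (Gmap K n1 d pw pu rw ru Phi) x0 c - xs c) < eps) /\
       (forall k : nat,
          linf K n1 d (fun c => Nat.iter k (Gmap K n1 d pw pu rw ru Phi) x0 c - xs c)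
          <= r ^ k * mu K n1 d gam (Gmap K n1 d pw pu rw ru Phi x0) x0
             / ((1 - r) * Rmin (gam K / ru) (rminn K gam / rw)))).
Proof.
destruct HC2 as [U [HU [HBU HC2U]]]. destruct Hgam_eig as [lam Heig].
assert (HgB : forall x, B_pp K n1 d pw pu rw ru x -> forall c, inR K n1 d c = true -> 0 < pd Phi x c)
  by (intros; apply Hgradpos; auto).
assert (HgS : forall x, S_plus K n1 d pw pu rw ru x -> forall c, inR K n1 d c = true -> 0 < pd Phi x c)
  by (intros; apply Hgradpos; auto).
assert (Hlam : 0 <= lam <= r)
  by (apply (left_eigenvalue_le_spectral_radius (S K) A gam); auto; intros; [apply HAnn|apply Hgam_pos|apply Heig]; lia).
assert (HGS : forall x, S_pp K n1 d pw pu rw ru x -> S_pp K n1 d pw pu rw ru (Gmap K n1 d pw pu rw ru Phi x))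
  by (intros x Sx; apply Gmap_S_pp; auto; apply HgS, Sx).
assert (Hcontr : forall x y, B_pp K n1 d pw pu rw ru x -> B_pp K n1 d pw pu rw ru y ->
  mu K n1 d gam (Gmap K n1 d pw pu rw ru Phi x) (Gmap K n1 d pw pu rw ru Phi y)
  <= lam * mu K n1 d gam x y)
  by (intros; apply (Gmap_contraction K n1 d pw pu rw ru U Phi A); auto; split; auto).
destruct (Phi_max_on_S_plus K n1 d pw pu rw ru Phi) as [xs [Sxs Hmax]]; auto.
assert (Hfix : Gmap K n1 d pw pu rw ru Phi xs = xs) by (apply maximizer_Gmap_fixed; auto).
assert (Sppxs : S_pp K n1 d pw pu rw ru xs) by (rewrite <- Hfix; apply Gmap_S_pp; auto).
exists xs. split; [|split; [|split]].
- apply crit_pt_of_Gmap_fixed; auto.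
- intros y Cy. apply (fixed_point_unique K n1 d pw pu rw ru gam (Gmap K n1 d pw pu rw ru Phi) lam r); auto; [apply Cy|].
  apply Gmap_fixed_of_crit_pt; auto. apply HgS, Cy.
- exact Hmax.
- intros x0 Sx0. split.
  + apply (iterate_cv K n1 d pw pu rw ru gam (Gmap K n1 d pw pu rw ru Phi) lam r); auto.
  + apply (iterate_linf_le K n1 d pw pu rw ru gam (Gmap K n1 d pw pu rw ru Phi) lam r); auto.
Qed.
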